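(* Let $\mathcal{U}$ be a CFI on $X=[0,1]$ with slope interval $S=[\underline s,\bar s]$ and level boundaries $\underline u\le\bar u$, where $\bar u$ is differentiable on $[0,1]$. A function $u\in\mathcal{U}$ is an extreme point of $\mathcal{U}$ if and only if there exists a (possibly empty) countable collection $\mathcal{X}=\{X_n\}_{n\in\mathbb{N}}$ of maximal, non-degenerate intervals $X_n=[a_n,b_n]\subseteq X$ ($a_n<b_n$) such that: 1. For all $x\notin\bigcup_n X_n$, $u(x)\in\{\underline u(x),\bar u(x)\}$. 2. For each $n$, $u|_{X_n}$ is affine, $\underline u<u<\bar u$ on $\mathrm{int}(X_n)$, and at least one of the following holds: (a) (tangential saturation) there is $y\in\{a_n,b_n\}$ such that $u(x)=\bar u(y)+s(x-y)$ for all $x\in X_n$, where $s=\bar u'(y)$ if $y\in(0,1)$, $s\in\{\underline s,\partial_+\bar u(0)\}$ if $y=0$, and $s\in\{\bar s,\partial_-\bar u(1)\}$ if $y=1$; (b) (chordal saturation) for each endpoint $x\in\{a_n,b_n\}$, either $u(x)=\underline u(x)$, or there exists $m$ with $X_m$ adjacent to $X_n$ at $x$ (i.e. $b_m=a_n=x$ or $a_m=b_n=x$) such that $u|_{X_m}$ satisfies (a); (c) (slope saturation) either $a_n=0$, $u'=\underline s$ on $X_n$, and either $u(b_n)=\underline u(b_n)$ or there is $m$ with $a_m=b_n$ and $u|_{X_m}$ satisfying (a); or, symmetrically, $b_n=1$, $u'=\bar s$ on $X_n$, and either $u(a_n)=\underline u(a_n)$ or there is $m$ with $b_m=a_n$ and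 $u|_{X_m}$ satisfying (a); (d) either $a_n=0$, $u(0)\in\{\underline u(0),\bar u(0)\}$, and either $u(b_n)=\underline u(b_n)$ or there is $m$ with $a_m=b_n$ and $u|_{X_m}$ satisfying (a); or, symmetrically, $b_n=1$, $u(1)\in\{\underline u(1),\bar u(1)\}$, and either $u(a_n)=\underline u(a_n)$ or there is $m$ with $b_m=a_n$ and $u|_{X_m}$ satisfying (a). Here maximality of $X_n=[a_n,b_n]$ means that for every $\varepsilon>0$, neither $u|_{[a_n-\varepsilon,b_n]}$ nor $u|_{[a_n,b_n+\varepsilon]}$ satisfies the requirements listed in item 2.
   Context: For a compact interval $X\subset\mathbb{R}$, $\mathcal{K}(X)$ denotes the set of real-valued continuous convex functions on $X$. For $u\in\mathcal{K}(X)$ and $x\in X$, $\partial u(x)=\{s\in\mathbb{R}: u(y)\ge u(x)+s(y-x)\ \forall y\in X\}$, and $\partial u(X):=\bigcup_{x\in\mathrm{int}(X)}\partial u(x)$; $\partial_-u,\partial_+u$ are the left and right derivatives. A convex function interval (CFI) is a set $\mathcal{U}=\{u\in\mathcal{K}(X):\ \underline{u}\le u\le \bar u,\ \partial u(X)\subseteq S\}$, where $X=[a,b]$ and $S=[\underline s,\bar s]$ are compact intervals and $\underline u,\bar u\in\mathcal{K}(X)$ satisfy $\underline u\le \bar u$ and $\partial\underline u(X),\partial\bar u(X)\subseteq S$. Extreme points are defined as usual for convex sets. *)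

From Stdlib Require Import Reals Lra.
Open Scope R_scope.

Definition inX (x : R) : Prop := 0 <= x <= 1.

Definition cont_on_X (f : R -> R) : Prop :=
  forall x, inX x -> forall eps, 0 < eps -> exists delta, 0 < delta /\
    forall y, inX y -> Rabs (y - x) < delta -> Rabs (f y - f x) < eps.

Definition convex_on_X (f : R -> R) : Prop :=
  forall x y t, inX x -> inX y -> 0 <= t <= 1 ->
    f (t * x + (1 - t) * y) <= t * f x + (1 - t) * f y.

Definition in_K (f : R -> R) : Prop := cont_on_X f /\ convex_on_X f.

Definition subgrad (f : R -> R) (x s : R) : Prop :=
  forall y, inX y -> f y >= f x + s * (y - x).

(* \partial f(X) \subseteq [sl, sh], with \partial f(X) the union over int(X) *)
Definition subdiff_in (f : R -> R) (sl sh : R) : Prop :=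
  forall x s, 0 < x < 1 -> subgrad f x s -> sl <= s <= sh.

Definition CFI (lo hi : R -> R) (sl sh : R) (v : R -> R) : Prop :=
  in_K v /\ (forall x, inX x -> lo x <= v x <= hi x) /\ subdiff_in v sl sh.

(* extreme point of a convex set of functions on X (functions identified on X) *)
Definition is_extreme (U : (R -> R) -> Prop) (u : R -> R) : Prop :=
  U u /\
  forall v w t, U v -> U w -> 0 < t < 1 ->
    (forall x, inX x -> u x = t * v x + (1 - t) * w x) ->
    forall x, inX x -> v x = w x.

Definition is_right_deriv (f : R -> R) (x l : R) : Prop :=
  forall eps, 0 < eps -> exists delta, 0 < delta /\
    forall h, 0 < h < delta -> Rabs ((f (x + h) - f x) / h - l) < eps.

Definition is_left_deriv (f : R -> R) (x l : R) : Prop :=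
  forall eps, 0 < eps -> exists delta, 0 < delta /\
    forall h, 0 < h < delta -> Rabs ((f (x - h) - f x) / (- h) - l) < eps.

Definition affine_on (u : R -> R) (c d : R) : Prop :=
  exists p q, forall x, c <= x <= d -> u x = p + q * x.

Definition tangential (hi : R -> R) (sl sh : R) (u : R -> R) (c d : R) : Prop :=
  exists y s, (y = c \/ y = d) /\
    ((0 < y < 1 /\ derivable_pt_lim hi y s) \/
     (y = 0 /\ (s = sl \/ is_right_deriv hi 0 s)) \/
     (y = 1 /\ (s = sh \/ is_left_deriv hi 1 s))) /\
    forall x, c <= x <= d -> u x = hi y + s * (x - y).

(* A countable (possibly empty) collection of intervals X_n = [a n, b n],
   indexed by the n : nat with I n. *)
Section Item2.
Variables (lo hi : R -> R) (sl sh : R) (u : R -> R)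
          (I : nat -> Prop) (a b : nat -> R).

Definition tang_m (m : nat) : Prop := tangential hi sl sh u (a m) (b m).

Definition left_ok (c : R) : Prop :=
  u c = lo c \/ exists m, I m /\ b m = c /\ tang_m m.
Definition right_ok (d : R) : Prop :=
  u d = lo d \/ exists m, I m /\ a m = d /\ tang_m m.

Definition chordal (c d : R) : Prop := left_ok c /\ right_ok d.

Definition slope_sat (c d : R) : Prop :=
  (c = 0 /\ (forall x, c < x < d -> derivable_pt_lim u x sl) /\ right_ok d) \/
  (d = 1 /\ (forall x, c < x < d -> derivable_pt_lim u x sh) /\ left_ok c).

Definition boundary_sat (c d : R) : Prop :=
  (c = 0 /\ (u 0 = lo 0 \/ u 0 = hi 0) /\ right_ok d) \/
  (d = 1 /\ (u 1 = lo 1 \/ u 1 = hi 1) /\ left_ok c).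

Definition item2 (c d : R) : Prop :=
  0 <= c /\ c < d /\ d <= 1 /\
  affine_on u c d /\
  (forall x, c < x < d -> lo x < u x < hi x) /\
  (tangential hi sl sh u c d \/ chordal c d \/ slope_sat c d \/ boundary_sat c d).

Definition maximal_item2 (c d : R) : Prop :=
  forall eps, 0 < eps -> ~ item2 (c - eps) d /\ ~ item2 c (d + eps).

Definition good_collection : Prop :=
  (forall x, inX x -> (forall n, I n -> ~ (a n <= x <= b n)) ->
     u x = lo x \/ u x = hi x) /\
  (forall n, I n -> item2 (a n) (b n) /\ maximal_item2 (a n) (b n)).
End Item2.

From Stdlib Require Import Reals Lra Classical ClassicalEpsilon ZArith Cantor.
Open Scope R_scope.
(* Sufficiency: if [u = t v + (1 - t) w] with [v], [w] in [U], then [v = u] wherever [u] meets [lo] or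
   [hi]; on an interval [X_n] where [u] is affine so are [v] and [w], and each of the saturation
   conditions (a)-(d) pins two values of [v], or a value and its slope, hence [v = u] on [X_n].
   Necessity: where [lo < u < hi] an extreme [u] is locally affine, since four points at which [u] bends
   allow a perturbation [u +/- l * psi], built from [u] minus its supporting lines, that stays in [U].
   The maximal affine pieces of this strict region, enumerated through the rationals they contain, form
   the collection. A maximal piece violating all of (a)-(d) could be bent at an end, or at its junction
   with a neighbouring piece, by a small tent function, again contradicting extremality. *)

(** * Convex functions on an interval *)

Definition convex_on (a b : R) (f : R -> R) : Prop :=
  forall x y t, a <= x <= b -> a <= y <= b -> 0 <= t <= 1 ->
    f (t * x + (1 - t) * y) <= t * f x + (1 - t) * f y.

Lemma convex_X_on01 f : convex_on_X f -> convex_on 0 1 f.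
Proof. unfold convex_on_X, convex_on, inX; intros H x y t Hx Hy Ht; apply H; auto. Qed.

Lemma convex_on01_X f : convex_on 0 1 f -> convex_on_X f.
Proof. unfold convex_on_X, convex_on, inX; intros H x y t Hx Hy Ht; apply H; auto. Qed.

Lemma convex_on_chord a b f x z y : convex_on a b f -> a <= x -> x < z -> z < y -> y <= b ->
  (y - x) * f z <= (y - z) * f x + (z - x) * f y.
Proof.
  intros H h1 h2 h3 h4.
  set (t := (y - z) / (y - x)).
  assert (Hyx : 0 < y - x) by lra.
  assert (Ht : t * (y - x) = y - z) by (unfold t; field; lra).
  assert (Ht0 : 0 <= t <= 1).
  { split.
    - unfold t; apply Rmult_le_pos; [lra| left; apply Rinv_0_lt_compat; lra].
    - apply (Rmult_le_reg_r (y - x)); [lra|]. rewrite Ht. lra. }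
  assert (Hz : z = t * x + (1 - t) * y).
  { apply (Rmult_eq_reg_r (y - x)); [|lra].
    replace ((t * x + (1 - t) * y) * (y - x)) with (t * (y - x) * x + (y * (y - x) - t * (y - x) * y)) by ring.
    rewrite Ht. ring. }
  assert (Hc := H x y t ltac:(lra) ltac:(lra) Ht0). rewrite <- Hz in Hc.
  assert (E: (y - x) * (t * f x + (1 - t) * f y) = (y - z) * f x + (z - x) * f y).
  { replace ((y - x) * (t * f x + (1 - t) * f y)) with (t * (y - x) * f x + (y - x) * f y - t * (y - x) * f y) by ring.
    rewrite Ht. ring. }
  rewrite <- E. apply Rmult_le_compat_l; lra.
Qed.

Lemma convex_on_of_chord a b f : (forall x z y, a <= x -> x < z -> z < y -> y <= b ->
  (y - x) * f z <= (y - z) * f x + (z - x) * f y) -> convex_on a b f.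
Proof.
  intros H x y t Hx Hy Ht.
  destruct (Req_dec t 0) as [->|Ht0]. { replace (0 * x + (1 - 0) * y) with y by ring. lra. }
  destruct (Req_dec t 1) as [->|Ht1]. { replace (1 * x + (1 - 1) * y) with x by ring. lra. }
  destruct (Rtotal_order x y) as [Hxy|[Hxy|Hxy]].
  - set (z := t * x + (1 - t) * y).
    assert (z - x = (1 - t) * (y - x)) by (unfold z; ring).
    assert (y - z = t * (y - x)) by (unfold z; ring).
    assert (0 < (1 - t) * (y - x)) by (apply Rmult_lt_0_compat; lra).
    assert (0 < t * (y - x)) by (apply Rmult_lt_0_compat; lra).
    assert (Hm := H x z y ltac:(lra) ltac:(lra) ltac:(lra) ltac:(lra)).
    apply (Rmult_le_reg_l (y - x)); [lra|].
    replace ((y - x) * (t * f x + (1 - t) * f y)) with ((y - z) * f x + (z - x) * f y).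
    + exact Hm.
    + rewrite H1, H0. ring.
  - subst. replace (t * y + (1 - t) * y) with y by ring. lra.
  - set (z := t * x + (1 - t) * y).
    assert (x - z = (1 - t) * (x - y)) by (unfold z; ring).
    assert (z - y = t * (x - y)) by (unfold z; ring).
    assert (0 < (1 - t) * (x - y)) by (apply Rmult_lt_0_compat; lra).
    assert (0 < t * (x - y)) by (apply Rmult_lt_0_compat; lra).
    assert (Hm := H y z x ltac:(lra) ltac:(lra) ltac:(lra) ltac:(lra)).
    apply (Rmult_le_reg_l (x - y)); [lra|].
    replace ((x - y) * (t * f x + (1 - t) * f y)) with ((x - z) * f y + (z - y) * f x).
    + exact Hm.
    + rewrite H1, H0. ring.
Qed.

Lemma convex_on_sub a b a' b' f : convex_on a b f -> a <= a' -> b' <= b -> convex_on a' b' f.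
Proof. intros H h1 h2 x y t Hx Hy Ht. apply H; lra. Qed.

Lemma convex_slope_from_le a b f x z y : convex_on a b f -> a <= x -> x < z -> z < y -> y <= b ->
  (f z - f x) * (y - x) <= (f y - f x) * (z - x).
Proof. intros H h1 h2 h3 h4. pose proof (convex_on_chord a b f x z y H h1 h2 h3 h4). lra. Qed.

Lemma convex_slope_to_le a b f x z y : convex_on a b f -> a <= x -> x < z -> z < y -> y <= b ->
  (f y - f x) * (y - z) <= (f y - f z) * (y - x).
Proof. intros H h1 h2 h3 h4. pose proof (convex_on_chord a b f x z y H h1 h2 h3 h4). lra. Qed.

Lemma convex_slope_adjacent_le a b f x z y : convex_on a b f -> a <= x -> x < z -> z < y -> y <= b ->
  (f z - f x) * (y - z) <= (f y - f z) * (z - x).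
Proof. intros H h1 h2 h3 h4. pose proof (convex_on_chord a b f x z y H h1 h2 h3 h4). lra. Qed.

Lemma convex_on_glue a m b f s : a <= m <= b -> convex_on a m f -> convex_on m b f ->
  (forall y, a <= y <= b -> f y >= f m + s * (y - m)) -> convex_on a b f.
Proof.
  intros Hm H1 H2 Hs. apply convex_on_of_chord. intros x z y hx hxz hzy hy.
  destruct (Rle_dec y m). { apply (convex_on_chord a m); [exact H1|lra..]. }
  destruct (Rle_dec m x). { apply (convex_on_chord m b); [exact H2|lra..]. }
  assert (Lm : (y - x) * f m <= (y - m) * f x + (m - x) * f y).
  { pose proof (Hs x ltac:(lra)). pose proof (Hs y ltac:(lra)).
    assert (A1: (y - m) * f x >= (y - m) * (f m + s * (x - m))) by (apply Rmult_ge_compat_l; lra).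
    assert (A2: (m - x) * f y >= (m - x) * (f m + s * (y - m))) by (apply Rmult_ge_compat_l; lra).
    lra. }
  destruct (Rtotal_order z m) as [Hz|[Hz|Hz]].
  - pose proof (convex_on_chord a m f x z m H1 ltac:(lra) hxz Hz ltac:(lra)) as C.
    apply (Rmult_le_reg_l (m - x)); [lra|].
    assert (B: (z - x) * ((y - x) * f m) <= (z - x) * ((y - m) * f x + (m - x) * f y)) by (apply Rmult_le_compat_l; lra).
    assert (C2 : (y - x) * ((m - x) * f z) <= (y - x) * ((m - z) * f x + (z - x) * f m)) by (apply Rmult_le_compat_l; lra).
    lra.
  - subst. lra.
  - pose proof (convex_on_chord m b f m z y H2 ltac:(lra) Hz hzy ltac:(lra)) as C.
    apply (Rmult_le_reg_l (y - m)); [lra|].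
    assert (B: (y - z) * ((y - x) * f m) <= (y - z) * ((y - m) * f x + (m - x) * f y)) by (apply Rmult_le_compat_l; lra).
    assert (C2 : (y - x) * ((y - m) * f z) <= (y - x) * ((y - z) * f m + (z - m) * f y)) by (apply Rmult_le_compat_l; lra).
    lra.
Qed.

Lemma subgrad_extend_left a m m' f s : convex_on a m f -> a <= m' -> m' < m ->
  (forall y, m' <= y <= m -> f y >= f m + s * (y - m)) ->
  forall y, a <= y <= m -> f y >= f m + s * (y - m).
Proof.
  intros H h1 h2 Hs y Hy. destruct (Rle_dec m' y). { apply Hs; lra. }
  pose proof (convex_slope_to_le a m f y m' m H ltac:(lra) ltac:(lra) ltac:(lra) ltac:(lra)) as T.
  pose proof (Hs m' ltac:(lra)) as S.
  assert (B : (f m - f m') * (m - y) <= s * (m - m') * (m - y)).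
  { apply Rmult_le_compat_r; lra. }
  assert (C: (f m - f y) * (m - m') <= s * (m - y) * (m - m')) by lra.
  assert (D: f m - f y <= s * (m - y)).
  { apply (Rmult_le_reg_r (m - m')); lra. }
  lra.
Qed.

Lemma affine_piece_subgrad a b f c d p : convex_on a b f -> a <= c -> c < d -> d <= b ->
  (forall x, c <= x <= d -> f x = f c + p * (x - c)) ->
  forall y, a <= y <= b -> f y >= f c + p * (y - c).
Proof.
  intros H h1 h2 h3 Hp y Hy.
  destruct (Rle_dec y d).
  - destruct (Rle_dec c y). { rewrite (Hp y); lra. }
    pose proof (convex_slope_to_le a b f y c d H ltac:(lra) ltac:(lra) ltac:(lra) ltac:(lra)) as T.
    rewrite (Hp d) in T by lra.
    assert (D: f c - f y <= p * (c - y)).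
    { apply (Rmult_le_reg_r (d - c)); [lra|].
      assert ((f c + p * (d - c) - f y) * (d - c) <= (f c + p * (d - c) - f c) * (d - y)) by lra.
      nra. }
    lra.
  - pose proof (convex_slope_from_le a b f c d y H ltac:(lra) ltac:(lra) ltac:(lra) ltac:(lra)) as T.
    rewrite (Hp d) in T by lra.
    assert (D: p * (y - c) <= f y - f c).
    { apply (Rmult_le_reg_r (d - c)); [lra|]. nra. }
    lra.
Qed.

Lemma convex_on_affine a b p q : convex_on a b (fun x => p + q * x).
Proof. intros x y t _ _ _. lra. Qed.

Lemma convex_comb_nonneg_eq0 t a b : 0 < t < 1 -> 0 <= a -> 0 <= b -> t * a + (1 - t) * b = 0 -> a = 0 /\ b = 0.
Proof.
  intros Ht Ha Hb E.
  assert (0 <= t * a) by (apply Rmult_le_pos; lra).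
  assert (0 <= (1 - t) * b) by (apply Rmult_le_pos; lra).
  assert (t * a = 0) by lra. assert ((1 - t) * b = 0) by lra.
  split.
  - destruct (Rmult_integral _ _ H1); lra.
  - destruct (Rmult_integral _ _ H2); lra.
Qed.

Lemma convex_comb_eq_bound t a b s : 0 < t < 1 -> ((a <= s /\ b <= s) \/ (s <= a /\ s <= b)) ->
  t * a + (1 - t) * b = s -> a = s /\ b = s.
Proof.
  intros Ht H E. destruct H as [[H1 H2]|[H1 H2]].
  - destruct (convex_comb_nonneg_eq0 t (s - a) (s - b)); try lra. 
  - destruct (convex_comb_nonneg_eq0 t (a - s) (b - s)); try lra.
Qed.

Lemma lt_mult_of_div_lt A B h : 0 < h -> A / h < B -> A < B * h.
Proof. intros Hh H. assert (A = (A / h) * h) by (field; lra). rewrite H0.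
  apply Rmult_lt_compat_r; lra. Qed.

Lemma mult_lt_of_lt_div A B h : 0 < h -> B < A / h -> B * h < A.
Proof. intros Hh H. assert (A = (A / h) * h) by (field; lra). rewrite H0.
  apply Rmult_lt_compat_r; lra. Qed.

Lemma derive_ge_of_right_line f c s P L : derivable_pt_lim f c s -> 0 < L ->
  (forall h, 0 < h <= L -> f c + P * h <= f (c + h)) -> P <= s.
Proof.
  intros D HL H. destruct (Rle_dec P s) as [|n]; [auto|exfalso].
  destruct (D (P - s) ltac:(lra)) as [[del Hd] Hdel]. simpl in Hdel.
  set (h := Rmin (del / 2) L).
  assert (hp : 0 < h) by (unfold h; apply Rmin_pos; lra).
  assert (hl : h <= L) by (unfold h; apply Rmin_r).
  assert (hd : h <= del / 2) by (unfold h; apply Rmin_l).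
  specialize (Hdel h ltac:(lra) ltac:(rewrite Rabs_right; lra)).
  apply Rabs_def2 in Hdel. destruct Hdel as [Hdel _].
  assert ((f (c + h) - f c) / h < P) by lra.
  apply lt_mult_of_div_lt in H0; [|lra]. specialize (H h ltac:(lra)). lra.
Qed.

Lemma derive_le_of_left_line f c s P L : derivable_pt_lim f c s -> 0 < L ->
  (forall h, 0 < h <= L -> f c - P * h <= f (c - h)) -> s <= P.
Proof.
  intros D HL H. destruct (Rle_dec s P) as [|n]; [auto|exfalso].
  destruct (D (s - P) ltac:(lra)) as [[del Hd] Hdel]. simpl in Hdel.
  set (h := Rmin (del / 2) L).
  assert (hp : 0 < h) by (unfold h; apply Rmin_pos; lra).
  assert (hl : h <= L) by (unfold h; apply Rmin_r).
  assert (hd : h <= del / 2) by (unfold h; apply Rmin_l).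
  specialize (Hdel (- h) ltac:(lra) ltac:(rewrite Rabs_left; lra)).
  apply Rabs_def2 in Hdel. destruct Hdel as [_ Hdel].
  replace (c + - h) with (c - h) in Hdel by ring.
  assert (P < (f c - f (c - h)) / h).
  { replace ((f c - f (c - h)) / h) with ((f (c - h) - f c) / - h) by (field; lra). lra. }
  apply mult_lt_of_lt_div in H0; [|lra]. specialize (H h ltac:(lra)). lra.
Qed.

Lemma right_deriv_ge_of_line f s P L : is_right_deriv f 0 s -> 0 < L ->
  (forall h, 0 < h <= L -> f 0 + P * h <= f h) -> P <= s.
Proof.
  intros D HL H. destruct (Rle_dec P s) as [|n]; [auto|exfalso].
  destruct (D (P - s) ltac:(lra)) as [del [Hd Hdel]].
  set (h := Rmin (del / 2) L).
  assert (hp : 0 < h) by (unfold h; apply Rmin_pos; lra).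
  assert (hl : h <= L) by (unfold h; apply Rmin_r).
  assert (hd : h <= del / 2) by (unfold h; apply Rmin_l).
  specialize (Hdel h ltac:(lra)).
  apply Rabs_def2 in Hdel. destruct Hdel as [Hdel _].
  replace (0 + h) with h in Hdel by ring.
  assert ((f h - f 0) / h < P) by lra.
  apply lt_mult_of_div_lt in H0; [|lra]. specialize (H h ltac:(lra)). lra.
Qed.

Lemma left_deriv_le_of_line f s P L : is_left_deriv f 1 s -> 0 < L ->
  (forall h, 0 < h <= L -> f 1 - P * h <= f (1 - h)) -> s <= P.
Proof.
  intros D HL H. destruct (Rle_dec s P) as [|n]; [auto|exfalso].
  destruct (D (s - P) ltac:(lra)) as [del [Hd Hdel]].
  set (h := Rmin (del / 2) L).
  assert (hp : 0 < h) by (unfold h; apply Rmin_pos; lra).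
  assert (hl : h <= L) by (unfold h; apply Rmin_r).
  assert (hd : h <= del / 2) by (unfold h; apply Rmin_l).
  specialize (Hdel h ltac:(lra)).
  apply Rabs_def2 in Hdel. destruct Hdel as [_ Hdel].
  assert (P < (f 1 - f (1 - h)) / h).
  { replace ((f 1 - f (1 - h)) / h) with ((f (1 - h) - f 1) / - h) by (field; lra). lra. }
  apply mult_lt_of_lt_div in H0; [|lra]. specialize (H h ltac:(lra)). lra.
Qed.

Lemma affine_derivable_pt_lim f c d q m : (forall x, c <= x <= d -> f x = f c + q * (x - c)) -> c < m < d ->
  derivable_pt_lim f m q.
Proof.
  intros H Hm eps He.
  assert (dp : 0 < Rmin (m - c) (d - m)) by (apply Rmin_pos; lra).
  exists (mkposreal _ dp). intros h hn hh. simpl in hh.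
  assert (h1 : Rabs h < m - c) by (eapply Rlt_le_trans; [exact hh| apply Rmin_l]).
  assert (h2 : Rabs h < d - m) by (eapply Rlt_le_trans; [exact hh| apply Rmin_r]).
  apply Rabs_def2 in h1. apply Rabs_def2 in h2.
  rewrite (H (m + h)) by lra. rewrite (H m) by lra.
  replace ((f c + q * (m + h - c) - (f c + q * (m - c))) / h - q) with 0 by (field; auto).
  rewrite Rabs_R0; lra.
Qed.

Lemma affine_on_slope_form f c d : c < d -> affine_on f c d -> exists q, forall x, c <= x <= d -> f x = f c + q * (x - c).
Proof.
  intros Hcd [p [q H]]. exists q. intros x Hx. rewrite (H x Hx), (H c ltac:(lra)). ring.
Qed.

Lemma CFI_affine_slope_bounds sl sh lo hi f c d p : CFI lo hi sl sh f -> 0 <= c -> c < d -> d <= 1 ->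
  (forall x, c <= x <= d -> f x = f c + p * (x - c)) -> sl <= p <= sh.
Proof.
  intros [[_ Hc] [_ Hs]] h1 h2 h3 H.
  set (m := (c + d) / 2).
  assert (Hm : forall x, m <= x <= d -> f x = f m + p * (x - m)).
  { intros x Hx. unfold m in *. rewrite (H x) by lra. rewrite (H ((c+d)/2)) by lra. ring. }
  apply (Hs m p). unfold m; lra.
  intros y Hy. apply (affine_piece_subgrad 0 1 f m d p (convex_X_on01 _ Hc)); unfold m in *; unfold inX in Hy; try lra; auto.
Qed.

Lemma convex_comb_on_chord (u f g : R -> R) t c d x : 0 < t < 1 -> convex_on 0 1 f -> convex_on 0 1 g ->
  0 <= c -> c < x -> x < d -> d <= 1 ->
  (forall y, inX y -> u y = t * f y + (1 - t) * g y) ->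
  (d - c) * u x = (d - x) * u c + (x - c) * u d ->
  (d - c) * f x = (d - x) * f c + (x - c) * f d.
Proof.
  intros Ht Cf Cg h1 h2 h3 h4 Hc E.
  pose proof (convex_on_chord 0 1 f c x d Cf h1 h2 h3 h4).
  pose proof (convex_on_chord 0 1 g c x d Cg h1 h2 h3 h4).
  rewrite (Hc x), (Hc c), (Hc d) in E by (unfold inX; lra).
  destruct (convex_comb_nonneg_eq0 t ((d - x) * f c + (x - c) * f d - (d - c) * f x)
                      ((d - x) * g c + (x - c) * g d - (d - c) * g x)); try lra.
Qed.

(** * Sufficiency *)

(* Affine members of [U] touching [hi] at a tangency point all lie on the same side of the tangent slope. *)
Lemma tangent_slope_one_side sl sh lo hi c d y s : 0 <= c -> c < d -> d <= 1 -> (y = c \/ y = d) ->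
  ((0 < y < 1 /\ derivable_pt_lim hi y s) \/ (y = 0 /\ (s = sl \/ is_right_deriv hi 0 s)) \/
   (y = 1 /\ (s = sh \/ is_left_deriv hi 1 s))) ->
  (forall f P, CFI lo hi sl sh f -> (forall x, c <= x <= d -> f x = f c + P * (x - c)) ->
     f y = hi y -> P <= s) \/
  (forall f P, CFI lo hi sl sh f -> (forall x, c <= x <= d -> f x = f c + P * (x - c)) ->
     f y = hi y -> s <= P).
Proof.
  intros h1 h2 h3 Hy Hcase.
  assert (Below_c : forall f P, CFI lo hi sl sh f -> (forall x, c <= x <= d -> f x = f c + P * (x - c)) ->
     f c = hi c -> forall h, 0 < h <= d - c -> hi c + P * h <= hi (c + h)).
  { intros f P Hf Af Ef h Hh. rewrite <- Ef. replace (f c + P * h) with (f (c + h))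
      by (rewrite (Af (c + h)) by lra; ring).
    apply (proj1 (proj2 Hf)); unfold inX; lra. }
  assert (Below_d : forall f P, CFI lo hi sl sh f -> (forall x, c <= x <= d -> f x = f c + P * (x - c)) ->
     f d = hi d -> forall h, 0 < h <= d - c -> hi d - P * h <= hi (d - h)).
  { intros f P Hf Af Ef h Hh. rewrite <- Ef. replace (f d - P * h) with (f (d - h))
      by (rewrite (Af (d - h)), (Af d) by lra; ring).
    apply (proj1 (proj2 Hf)); unfold inX; lra. }
  destruct Hcase as [[Hy1 Hd]|[[Hy0 [->|Hs]]|[Hy1 [->|Hs]]]].
  - destruct Hy as [->| ->]; [left|right]; intros f P Hf Af Ef.
    + apply (derive_ge_of_right_line hi c s P (d - c) Hd ltac:(lra)). exact (Below_c f P Hf Af Ef).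
    + apply (derive_le_of_left_line hi d s P (d - c) Hd ltac:(lra)). exact (Below_d f P Hf Af Ef).
  - right. intros f P Hf Af _. exact (proj1 (CFI_affine_slope_bounds sl sh lo hi f c d P Hf h1 h2 h3 Af)).
  - assert (c = 0) by (destruct Hy; lra). subst y c. left. intros f P Hf Af Ef.
    apply (right_deriv_ge_of_line hi s P d Hs ltac:(lra)). intros h Hh.
    replace h with (0 + h) at 2 by ring. apply (Below_c f P Hf Af Ef); lra.
  - left. intros f P Hf Af _. exact (proj2 (CFI_affine_slope_bounds sl sh lo hi f c d P Hf h1 h2 h3 Af)).
  - assert (d = 1) by (destruct Hy; lra). subst y d. right. intros f P Hf Af Ef.
    apply (left_deriv_le_of_line hi s P (1 - c) Hs ltac:(lra)). exact (Below_d f P Hf Af Ef).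
Qed.

Section CombinationPinning.
Variables (sl sh : R) (lo hi u v w : R -> R) (t : R).
Hypothesis Hv : CFI lo hi sl sh v.
Hypothesis Hw : CFI lo hi sl sh w.
Hypothesis Ht : 0 < t < 1.
Hypothesis Hcomb : forall x, inX x -> u x = t * v x + (1 - t) * w x.

Lemma comb_other_eq x : inX x -> v x = u x -> w x = u x.
Proof.
  intros Hx E. pose proof (Hcomb x Hx). rewrite E in H.
  assert ((1 - t) * (w x - u x) = 0) by lra.
  destruct (Rmult_integral _ _ H0); lra.
Qed.

Lemma comb_pinned_at_bound x : inX x -> (u x = lo x \/ u x = hi x) -> v x = u x.
Proof.
  intros Hx H. destruct Hv as [_ [Bv _]]. destruct Hw as [_ [Bw _]].
  specialize (Bv x Hx). specialize (Bw x Hx). pose proof (Hcomb x Hx).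
  destruct H as [H|H].
  - destruct (convex_comb_nonneg_eq0 t (v x - lo x) (w x - lo x)); lra.
  - destruct (convex_comb_nonneg_eq0 t (hi x - v x) (hi x - w x)); lra.
Qed.

Lemma comb_affine_parts c d q : 0 <= c -> c < d -> d <= 1 ->
  (forall x, c <= x <= d -> u x = u c + q * (x - c)) ->
  (forall x, c <= x <= d -> v x = v c + ((v d - v c) / (d - c)) * (x - c)) /\
  (forall x, c <= x <= d -> w x = w c + ((w d - w c) / (d - c)) * (x - c)) /\
  t * ((v d - v c) / (d - c)) + (1 - t) * ((w d - w c) / (d - c)) = q.
Proof.
  intros h1 h2 h3 Hu.
  destruct Hv as [[_ Cv] _]. destruct Hw as [[_ Cw] _].
  apply convex_X_on01 in Cv. apply convex_X_on01 in Cw.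
  assert (Hc' : forall y, inX y -> u y = (1 - t) * w y + (1 - (1 - t)) * v y).
  { intros y Hy. rewrite (Hcomb y Hy). ring. }
  assert (E : forall x, c < x < d -> (d - c) * u x = (d - x) * u c + (x - c) * u d).
  { intros x Hx. rewrite (Hu x), (Hu d) by lra. ring. }
  split; [|split].
  - intros x Hx. destruct (Req_dec x c) as [->|]. { ring_simplify. auto. }
    destruct (Req_dec x d) as [->|]. { field. lra. }
    pose proof (convex_comb_on_chord u v w t c d x Ht Cv Cw h1 ltac:(lra) ltac:(lra) h3 Hcomb (E x ltac:(lra))).
    apply (Rmult_eq_reg_l (d - c)); [|lra]. rewrite H1. field. lra.
  - intros x Hx. destruct (Req_dec x c) as [->|]. { ring_simplify. auto. }
    destruct (Req_dec x d) as [->|]. { field. lra. }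
    assert (Ht' : 0 < 1 - t < 1) by lra.
    pose proof (convex_comb_on_chord u w v (1 - t) c d x Ht' Cw Cv h1 ltac:(lra) ltac:(lra) h3 Hc' (E x ltac:(lra))).
    apply (Rmult_eq_reg_l (d - c)); [|lra]. rewrite H1. field. lra.
  - pose proof (Hcomb c ltac:(unfold inX; lra)). pose proof (Hcomb d ltac:(unfold inX; lra)).
    rewrite (Hu d) in H0 by lra.
    assert (X: t*((v d - v c)/(d - c)) + (1-t)*((w d - w c)/(d - c)) = ((t * v d + (1-t) * w d) - (t * v c + (1 - t) * w c)) / (d - c)) by (field; lra).
    rewrite X, <- H, <- H0. field. lra.
Qed.

Lemma comb_pinned_ends c d q : 0 <= c -> c < d -> d <= 1 ->
  (forall x, c <= x <= d -> u x = u c + q * (x - c)) ->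
  v c = u c -> v d = u d -> forall x, c <= x <= d -> v x = u x.
Proof.
  intros h1 h2 h3 Hu E1 E2 x Hx. destruct (comb_affine_parts c d q h1 h2 h3 Hu) as [A _].
  rewrite (A x Hx), (Hu x Hx), E1, E2, (Hu d) by lra. field. lra.
Qed.

Lemma comb_pinned_slope c d q y : 0 <= c -> c < d -> d <= 1 ->
  (forall x, c <= x <= d -> u x = u c + q * (x - c)) -> (y = c \/ y = d) ->
  v y = u y -> (v d - v c) / (d - c) = q -> forall x, c <= x <= d -> v x = u x.
Proof.
  intros h1 h2 h3 Hu Hy E S x Hx. destruct (comb_affine_parts c d q h1 h2 h3 Hu) as [A _].
  rewrite S in A. rewrite (A x Hx), (Hu x Hx).
  destruct Hy as [->| ->]; [rewrite E; auto|].
  rewrite (A d) in E by lra. rewrite (Hu d) in E by lra. lra.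
Qed.

Lemma tangential_pinned c d : 0 <= c -> c < d -> d <= 1 ->
  tangential hi sl sh u c d -> forall x, c <= x <= d -> v x = u x.
Proof.
  intros h1 h2 h3 [y [s [Hy [Hcase Hu]]]].
  assert (Hq : forall x, c <= x <= d -> u x = u c + s * (x - c)).
  { intros x Hx. rewrite (Hu x Hx), (Hu c ltac:(lra)). ring. }
  assert (Hyc : inX y) by (unfold inX; destruct Hy; lra).
  assert (Huy : u y = hi y) by (rewrite (Hu y) by (destruct Hy; lra); ring).
  assert (Evy : v y = u y) by (apply comb_pinned_at_bound; auto).
  assert (Ewy : w y = u y) by (apply comb_other_eq; auto).
  destruct (comb_affine_parts c d s h1 h2 h3 Hq) as [Av [Aw Comb]].
  assert (Key : (v d - v c) / (d - c) = s).
  { apply (convex_comb_eq_bound t _ ((w d - w c) / (d - c)) s Ht); [|exact Comb].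
    destruct (tangent_slope_one_side sl sh lo hi c d y s h1 h2 h3 Hy Hcase) as [Side|Side];
      [left|right]; (split; [apply (Side v)|apply (Side w)]; auto; congruence). }
  exact (comb_pinned_slope c d s y h1 h2 h3 Hq Hy Evy Key).
Qed.

End CombinationPinning.

Section CollectionPinning.
Variables (sl sh : R) (lo hi u v w : R -> R) (t : R).
Hypothesis Hv : CFI lo hi sl sh v.
Hypothesis Hw : CFI lo hi sl sh w.
Hypothesis Ht : 0 < t < 1.
Hypothesis Hcomb : forall x, inX x -> u x = t * v x + (1 - t) * w x.
Variables (I : nat -> Prop) (a b : nat -> R).
Hypothesis HI : forall n, I n -> item2 lo hi sl sh u I a b (a n) (b n).

Lemma tang_m_pinned m : I m -> tang_m hi sl sh u a b m -> forall x, a m <= x <= b m -> v x = u x.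
Proof.
  intros Im Tm. destruct (HI m Im) as [h1 [h2 [h3 [Ha _]]]].
  apply (tangential_pinned sl sh lo hi u v w t Hv Hw Ht Hcomb); auto.
Qed.

Lemma left_ok_pinned c : inX c -> left_ok lo hi sl sh u I a b c -> v c = u c.
Proof.
  intros Hc [H|[m [Im [Eb Tm]]]].
  - apply (comb_pinned_at_bound sl sh lo hi u v w t Hv Hw Ht Hcomb); auto.
  - destruct (HI m Im) as [h1 [h2 [h3 _]]].
    apply (tang_m_pinned m Im Tm). lra.
Qed.

Lemma right_ok_pinned c : inX c -> right_ok lo hi sl sh u I a b c -> v c = u c.
Proof.
  intros Hc [H|[m [Im [Eb Tm]]]].
  - apply (comb_pinned_at_bound sl sh lo hi u v w t Hv Hw Ht Hcomb); auto.
  - destruct (HI m Im) as [h1 [h2 [h3 _]]].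
    apply (tang_m_pinned m Im Tm). lra.
Qed.

Lemma item2_pinned c d : item2 lo hi sl sh u I a b c d -> forall x, c <= x <= d -> v x = u x.
Proof.
  intros [h1 [h2 [h3 [Ha [Hs Hc]]]]].
  destruct (affine_on_slope_form u c d h2 Ha) as [q Hq].
  assert (ic : inX c) by (unfold inX; lra). assert (id : inX d) by (unfold inX; lra).
  destruct (comb_affine_parts sl sh lo hi u v w t Hv Hw Ht Hcomb c d q h1 h2 h3 Hq) as [Av [Aw Comb]].
  set (pv := (v d - v c) / (d - c)) in *. set (pw := (w d - w c) / (d - c)) in *.
  assert (Sv : sl <= pv <= sh) by (apply (CFI_affine_slope_bounds sl sh lo hi v c d); auto).
  assert (Sw : sl <= pw <= sh) by (apply (CFI_affine_slope_bounds sl sh lo hi w c d); auto).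
  assert (Qd : forall s, (forall x, c < x < d -> derivable_pt_lim u x s) -> q = s).
  { intros s D. apply (uniqueness_limite u ((c + d) / 2)).
    - apply (affine_derivable_pt_lim u c d q); auto; lra.
    - apply D; lra. }
  destruct Hc as [T|[[L R]|[S|B]]].
  - apply (tangential_pinned sl sh lo hi u v w t Hv Hw Ht Hcomb); auto.
  - apply (comb_pinned_ends sl sh lo hi u v w t Hv Hw Ht Hcomb c d q); auto.
    apply left_ok_pinned; auto. apply right_ok_pinned; auto.
  - destruct S as [[E [D R]]|[E [D L]]].
    + apply (Qd sl) in D. subst q.
      destruct (convex_comb_eq_bound t pv pw sl Ht) as [Ev _]; [right; lra|auto|].
      apply (comb_pinned_slope sl sh lo hi u v w t Hv Hw Ht Hcomb c d sl d); auto.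
      apply right_ok_pinned; auto.
    + apply (Qd sh) in D. subst q.
      destruct (convex_comb_eq_bound t pv pw sh Ht) as [Ev _]; [left; lra|auto|].
      apply (comb_pinned_slope sl sh lo hi u v w t Hv Hw Ht Hcomb c d sh c); auto.
      apply left_ok_pinned; auto.
  - destruct B as [[E [U R]]|[E [U L]]].
    + subst c. apply (comb_pinned_ends sl sh lo hi u v w t Hv Hw Ht Hcomb 0 d q); auto.
      apply (comb_pinned_at_bound sl sh lo hi u v w t Hv Hw Ht Hcomb); auto.
      apply right_ok_pinned; auto.
    + subst d. apply (comb_pinned_ends sl sh lo hi u v w t Hv Hw Ht Hcomb c 1 q); auto.
      apply left_ok_pinned; auto.
      apply (comb_pinned_at_bound sl sh lo hi u v w t Hv Hw Ht Hcomb); auto.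
Qed.

End CollectionPinning.

Lemma good_collection_extreme sl sh lo hi u I a b : good_collection lo hi sl sh u I a b ->
  forall v w t, CFI lo hi sl sh v -> CFI lo hi sl sh w -> 0 < t < 1 ->
    (forall x, inX x -> u x = t * v x + (1 - t) * w x) ->
    forall x, inX x -> v x = w x.
Proof.
  intros [G1 G2] v w t Hv Hw Ht Hc x Hx.
  assert (HI : forall n, I n -> item2 lo hi sl sh u I a b (a n) (b n)) by (intros n In; apply G2; auto).
  assert (Vx : v x = u x).
  { destruct (classic (exists n, I n /\ a n <= x <= b n)) as [[n [In Hn]]|N].
    - apply (item2_pinned sl sh lo hi u v w t Hv Hw Ht Hc I a b HI (a n) (b n)); auto.
    - apply (comb_pinned_at_bound sl sh lo hi u v w t Hv Hw Ht Hc); auto.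
      apply G1; auto. intros n In Hn. apply N. exists n; auto. }
  rewrite Vx. symmetry. eapply comb_other_eq; eauto.
Qed.

(** * Perturbations of [u] inside [U] *)

Lemma cont_pos_lower_bound f p q : cont_on_X f -> 0 <= p -> p <= q -> q <= 1 ->
  (forall x, p <= x <= q -> 0 < f x) -> exists m, 0 < m /\ forall x, p <= x <= q -> m <= f x.
Proof.
  intros Hc hp hpq hq Hpos.
  set (S := fun s => p <= s <= q /\ exists m, 0 < m /\ forall x, p <= x <= s -> m <= f x).
  assert (Sp : S p).
  { split; [lra|]. exists (f p). split; [apply Hpos; lra|]. intros x Hx. replace x with p by lra. lra. }
  assert (Sb : bound S) by (exists q; intros s [Hs _]; lra).
  destruct (completeness S Sb (ex_intro _ p Sp)) as [sg [Ub Lub]].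
  assert (sgp : p <= sg) by (apply Ub; auto).
  assert (sgq : sg <= q) by (apply Lub; intros s [Hs _]; lra).
  assert (fs : 0 < f sg) by (apply Hpos; lra).
  destruct (Hc sg ltac:(unfold inX; lra) (f sg / 2) ltac:(lra)) as [del [Hd Hdel]].
  assert (Ex : exists s, S s /\ sg - del < s).
  { apply NNPP. intro N. assert (sg <= sg - del); [|lra].
    apply Lub. intros s Ss. apply Rnot_lt_le. intro Hs. apply N. exists s. auto. }
  destruct Ex as [s [[Hs [m [Hm Hms]]] Hs2]].
  set (s' := Rmin (sg + del / 2) q).
  assert (Ss' : S s').
  { split. { unfold s'. split; [apply Rmin_glb; lra| apply Rmin_r]. }
    exists (Rmin m (f sg / 2)). split. { apply Rmin_pos; lra. }
    intros x Hx. destruct (Rle_dec x s). { eapply Rle_trans; [apply Rmin_l| apply Hms; lra]. }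
    eapply Rle_trans; [apply Rmin_r|].
    assert (x <= sg + del / 2) by (eapply Rle_trans; [apply Hx| apply Rmin_l]).
    assert (x <= q) by (eapply Rle_trans; [apply Hx| apply Rmin_r]).
    specialize (Hdel x ltac:(unfold inX; lra) ltac:(apply Rabs_def1; lra)).
    apply Rabs_def2 in Hdel. lra. }
  assert (s' <= sg) by (apply Ub; auto).
  assert (s' = q).
  { unfold s' in *. destruct (Rle_dec (sg + del / 2) q).
    - rewrite Rmin_left in H by lra. lra.
    - rewrite Rmin_right by lra. auto. }
  destruct Ss' as [_ [m' [Hm' Hms']]]. exists m'. split; auto. intros x Hx. apply Hms'. lra.
Qed.

Lemma cont_on_X_minus f g : cont_on_X f -> cont_on_X g -> cont_on_X (fun x => f x - g x).
Proof.
  intros Hf Hg x Hx eps He.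
  destruct (Hf x Hx (eps/2) ltac:(lra)) as [d1 [Hd1 H1]].
  destruct (Hg x Hx (eps/2) ltac:(lra)) as [d2 [Hd2 H2]].
  exists (Rmin d1 d2). split; [apply Rmin_pos; auto|]. intros y Hy Hyx.
  specialize (H1 y Hy ltac:(eapply Rlt_le_trans; [exact Hyx| apply Rmin_l])).
  specialize (H2 y Hy ltac:(eapply Rlt_le_trans; [exact Hyx| apply Rmin_r])).
  apply Rabs_def2 in H1. apply Rabs_def2 in H2. apply Rabs_def1; lra.
Qed.

Lemma cont_on_X_opp f : cont_on_X f -> cont_on_X (fun x => - f x).
Proof.
  intros Hf x Hx eps He. destruct (Hf x Hx eps He) as [d [Hd H]].
  exists d. split; [exact Hd|]. intros y Hy Hyx.
  replace (- f y - - f x) with (- (f y - f x)) by ring. rewrite Rabs_Ropp. auto.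
Qed.

Lemma cont_on_X_add_affine f l a k : cont_on_X f -> cont_on_X (fun x => f x + l * (a + k * x)).
Proof.
  intros Hf x Hx eps He.
  destruct (Hf x Hx (eps/2) ltac:(lra)) as [d1 [Hd1 H1]].
  set (K := Rabs (l * k) + 1).
  assert (HK : 0 < K) by (unfold K; pose proof (Rabs_pos (l * k)); lra).
  exists (Rmin d1 (eps / 2 / K)). split. { apply Rmin_pos; auto. apply Rdiv_lt_0_compat; lra. }
  intros y Hy Hyx.
  specialize (H1 y Hy ltac:(eapply Rlt_le_trans; [exact Hyx| apply Rmin_l])).
  assert (Hy2 : Rabs (y - x) < eps / 2 / K) by (eapply Rlt_le_trans; [exact Hyx| apply Rmin_r]).
  replace (f y + l * (a + k * y) - (f x + l * (a + k * x))) with ((f y - f x) + (l * k) * (y - x)) by ring.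
  eapply Rle_lt_trans. apply Rabs_triang. rewrite Rabs_mult.
  assert (Rabs (l * k) * Rabs (y - x) <= K * Rabs (y - x)).
  { apply Rmult_le_compat_r. apply Rabs_pos. unfold K; lra. }
  assert (K * Rabs (y - x) < eps / 2).
  { apply (Rmult_lt_compat_l K) in Hy2; auto. replace (K * (eps / 2 / K)) with (eps / 2) in Hy2 by (field; lra). lra. }
  lra.
Qed.

Definition chord_slope (f : R -> R) x y := (f y - f x) / (y - x).

Lemma chord_slope_mono a b f x y x' y' : convex_on a b f -> a <= x -> x < y -> y <= x' -> x' < y' -> y' <= b ->
  chord_slope f x y <= chord_slope f x' y'.
Proof.
  intros H h1 h2 h3 h4 h5. unfold chord_slope.
  assert (A : (f y - f x) / (y - x) <= (f y' - f y) / (y' - y)).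
  { pose proof (convex_slope_adjacent_le a b f x y y' H h1 h2 ltac:(lra) h5).
    apply (Rmult_le_reg_r ((y - x) * (y' - y))). apply Rmult_lt_0_compat; lra.
    replace ((f y - f x) / (y - x) * ((y - x) * (y' - y))) with ((f y - f x) * (y' - y)) by (field; lra).
    replace ((f y' - f y) / (y' - y) * ((y - x) * (y' - y))) with ((f y' - f y) * (y - x)) by (field; lra).
    lra. }
  destruct (Req_dec y x') as [<-|Hne]; auto.
  assert (B : (f y' - f y) / (y' - y) <= (f y' - f x') / (y' - x')).
  { pose proof (convex_slope_to_le a b f y x' y' H ltac:(lra) ltac:(lra) h4 h5).
    apply (Rmult_le_reg_r ((y' - y) * (y' - x'))). apply Rmult_lt_0_compat; lra.
    replace ((f y' - f y) / (y' - y) * ((y' - y) * (y' - x'))) with ((f y' - f y) * (y' - x')) by (field; lra).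
    replace ((f y' - f x') / (y' - x') * ((y' - y) * (y' - x'))) with ((f y' - f x') * (y' - y)) by (field; lra).
    lra. }
  lra.
Qed.

Lemma convex_lipschitz_inner f a0 a b b0 : convex_on 0 1 f -> 0 <= a0 -> a0 < a -> a < b -> b < b0 -> b0 <= 1 ->
  exists L, 0 < L /\ forall y z, a <= y <= b -> a <= z <= b -> Rabs (f z - f y) <= L * Rabs (z - y).
Proof.
  intros H h1 h2 h3 h4 h5.
  set (L := Rabs (chord_slope f a0 a) + Rabs (chord_slope f b b0) + 1).
  exists L. split. { unfold L. pose proof (Rabs_pos (chord_slope f a0 a)). pose proof (Rabs_pos (chord_slope f b b0)). lra. }
  assert (K : forall y z, a <= y -> y < z -> z <= b -> Rabs (f z - f y) <= L * (z - y)).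
  { intros y z hy hyz hz.
    assert (S1 : chord_slope f a0 a <= chord_slope f y z) by (apply (chord_slope_mono 0 1); auto; lra).
    assert (S2 : chord_slope f y z <= chord_slope f b b0) by (apply (chord_slope_mono 0 1); auto; lra).
    assert (E : f z - f y = chord_slope f y z * (z - y)) by (unfold chord_slope; field; lra).
    rewrite E, Rabs_mult, (Rabs_right (z - y)) by lra.
    apply Rmult_le_compat_r; [lra|]. unfold L.
    pose proof (Rabs_pos (chord_slope f a0 a)). pose proof (Rabs_pos (chord_slope f b b0)).
    pose proof (Rle_abs (chord_slope f b b0)). pose proof (Rle_abs (- chord_slope f a0 a)). rewrite Rabs_Ropp in H3.
    apply Rabs_le. lra. }
  intros y z Hy Hz. destruct (Rtotal_order y z) as [Hl|[He|Hg]].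
  - rewrite (Rabs_right (z - y)) by lra. apply K; lra.
  - subst. rewrite !Rminus_diag_eq by auto. rewrite Rabs_R0. lra.
  - rewrite Rabs_minus_sym, (Rabs_left (z - y)) by lra.
    replace (- (z - y)) with (y - z) by ring. apply K; lra.
Qed.

Lemma convex_cont_on_X_of_ends v f1 f2 p q : convex_on 0 1 v -> 0 < p -> p < q -> q < 1 ->
  cont_on_X f1 -> cont_on_X f2 -> (forall x, 0 <= x <= p -> v x = f1 x) ->
  (forall x, q <= x <= 1 -> v x = f2 x) -> cont_on_X v.
Proof.
  intros Hv hp hpq hq C1 C2 E1 E2 x Hx eps He. unfold inX in Hx.
  destruct (Rlt_dec x p).
  - destruct (C1 x ltac:(unfold inX; lra) eps He) as [d [Hd Hdel]].
    exists (Rmin d (p - x)). split; [apply Rmin_pos; lra|]. intros y Hy Hyx.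
    assert (Rabs (y - x) < p - x) by (eapply Rlt_le_trans; [exact Hyx| apply Rmin_r]).
    apply Rabs_def2 in H. unfold inX in Hy.
    rewrite E1, E1 by lra. apply Hdel; auto. eapply Rlt_le_trans; [exact Hyx| apply Rmin_l].
  - destruct (Rlt_dec q x).
    + destruct (C2 x ltac:(unfold inX; lra) eps He) as [d [Hd Hdel]].
      exists (Rmin d (x - q)). split; [apply Rmin_pos; lra|]. intros y Hy Hyx.
      assert (Rabs (y - x) < x - q) by (eapply Rlt_le_trans; [exact Hyx| apply Rmin_r]).
      apply Rabs_def2 in H. unfold inX in Hy.
      rewrite E2, E2 by lra. apply Hdel; auto. eapply Rlt_le_trans; [exact Hyx| apply Rmin_l].
    + destruct (convex_lipschitz_inner v 0 (p / 2) ((1 + q) / 2) 1 Hv) as [L [HL HLip]]; try lra.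
      exists (Rmin (Rmin (p / 2) ((1 - q) / 2)) (eps / L)). split.
      { apply Rmin_pos; [apply Rmin_pos; lra| apply Rdiv_lt_0_compat; lra]. }
      intros y Hy Hyx.
      assert (A1 : Rabs (y - x) < Rmin (p / 2) ((1 - q) / 2)) by (eapply Rlt_le_trans; [exact Hyx| apply Rmin_l]).
      assert (A2 : Rabs (y - x) < eps / L) by (eapply Rlt_le_trans; [exact Hyx| apply Rmin_r]).
      assert (A3 : Rabs (y - x) < p / 2) by (eapply Rlt_le_trans; [exact A1| apply Rmin_l]).
      assert (A4 : Rabs (y - x) < (1 - q) / 2) by (eapply Rlt_le_trans; [exact A1| apply Rmin_r]).
      apply Rabs_def2 in A3. apply Rabs_def2 in A4.
      eapply Rle_lt_trans. apply HLip; lra.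
      apply (Rmult_lt_compat_l L) in A2; auto. replace (L * (eps / L)) with eps in A2 by (field; lra). lra.
Qed.

Lemma convex_subgrad_exists f m : convex_on 0 1 f -> 0 < m < 1 ->
  exists s, forall y, 0 <= y <= 1 -> f y >= f m + s * (y - m).
Proof.
  intros H Hm.
  set (E := fun z => exists y, 0 <= y < m /\ z = chord_slope f y m).
  assert (Eb : bound E).
  { exists (chord_slope f m 1). intros z [y [Hy ->]]. apply (chord_slope_mono 0 1); auto; lra. }
  assert (E0 : E (chord_slope f 0 m)) by (exists 0; split; [lra|auto]).
  destruct (completeness E Eb (ex_intro _ _ E0)) as [s [Ub Lub]].
  exists s. intros y Hy. destruct (Rtotal_order y m) as [Hl|[He|Hg]].
  - assert (chord_slope f y m <= s) by (apply Ub; exists y; split; auto; lra).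
    unfold chord_slope in H0.
    assert (f m - f y <= s * (m - y)).
    { apply (Rmult_le_compat_r (m - y)) in H0; [|lra].
      replace ((f m - f y) / (m - y) * (m - y)) with (f m - f y) in H0 by (field; lra). lra. }
    lra.
  - subst. lra.
  - assert (s <= chord_slope f m y).
    { apply Lub. intros z [y' [Hy' ->]]. apply (chord_slope_mono 0 1); auto; lra. }
    unfold chord_slope in H0.
    apply (Rmult_le_compat_r (y - m)) in H0; [|lra].
    replace ((f y - f m) / (y - m) * (y - m)) with (f y - f m) in H0 by (field; lra). lra.
Qed.

Lemma subdiff_chord_bounds sl sh f y y' : in_K f -> subdiff_in f sl sh -> 0 < y -> y < y' -> y' < 1 ->
  sl * (y' - y) <= f y' - f y <= sh * (y' - y).
Proof.
  intros [_ Hc] Hs h1 h2 h3. apply convex_X_on01 in Hc.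
  destruct (convex_subgrad_exists f y Hc ltac:(lra)) as [s1 H1].
  destruct (convex_subgrad_exists f y' Hc ltac:(lra)) as [s2 H2].
  assert (B1 : sl <= s1 <= sh) by (apply (Hs y s1); [lra| intros z Hz; apply H1; exact Hz]).
  assert (B2 : sl <= s2 <= sh) by (apply (Hs y' s2); [lra| intros z Hz; apply H2; exact Hz]).
  specialize (H1 y' ltac:(lra)). specialize (H2 y ltac:(lra)).
  assert (sl*(y'-y) <= s1*(y'-y)) by (apply Rmult_le_compat_r; lra).
  assert (s2*(y'-y) <= sh*(y'-y)) by (apply Rmult_le_compat_r; lra). lra.
Qed.

Lemma CFI_chord_slope_bounds sl sh lo hi f y y' : CFI lo hi sl sh f -> 0 < y -> y < y' -> y' < 1 ->
  sl <= chord_slope f y y' <= sh.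
Proof.
  intros [Hk [_ Hs]] h1 h2 h3. pose proof (subdiff_chord_bounds sl sh f y y' Hk Hs h1 h2 h3).
  assert (E : chord_slope f y y' * (y' - y) = f y' - f y) by (unfold chord_slope; field; lra).
  split; apply (Rmult_le_reg_r (y' - y)); lra.
Qed.

Definition small (P : R -> Prop) := exists k, 0 < k /\ forall l, Rabs l <= k -> P l.

Lemma small_and P Q : small P -> small Q -> small (fun l => P l /\ Q l).
Proof.
  intros [k1 [H1 P1]] [k2 [H2 P2]]. exists (Rmin k1 k2). split; [apply Rmin_pos; auto|].
  intros l Hl. split; [apply P1| apply P2]; eapply Rle_trans; eauto; [apply Rmin_l| apply Rmin_r].
Qed.

Lemma small_all (P : R -> Prop) : (forall l, P l) -> small P.
Proof. intros H. exists 1. split; [lra| auto]. Qed.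

Lemma small_imp (P Q : R -> Prop) : (forall l, P l -> Q l) -> small P -> small Q.
Proof. intros H [k [Hk Pk]]. exists k. split; auto. Qed.

Lemma small_le A B C : A < C -> small (fun l => A + l * B <= C).
Proof.
  intros H. exists ((C - A) / (Rabs B + 1)). split.
  { apply Rdiv_lt_0_compat; [lra|]. pose proof (Rabs_pos B); lra. }
  intros l Hl. pose proof (Rabs_pos B).
  assert (l * B <= Rabs l * Rabs B) by (rewrite <- Rabs_mult; apply Rle_abs).
  assert (Rabs l * Rabs B <= (C - A) / (Rabs B + 1) * Rabs B) by (apply Rmult_le_compat_r; auto).
  assert ((C - A) / (Rabs B + 1) * Rabs B <= C - A).
  { apply (Rmult_le_reg_r (Rabs B + 1)); [lra|].
    replace ((C - A) / (Rabs B + 1) * Rabs B * (Rabs B + 1)) with ((C - A) * Rabs B) by (field; lra). nra. }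
  lra.
Qed.

Lemma small_ge A B C : C < A -> small (fun l => C <= A + l * B).
Proof.
  intros H. apply (small_imp (fun l => - A + l * - B <= - C)); [intros l Hl; lra|].
  apply small_le. lra.
Qed.

Lemma small_absle m K : 0 < m -> small (fun l => Rabs l * K <= m).
Proof.
  intros Hm. apply (small_imp (fun l => 0 + Rabs l * K <= m)); [intros l Hl; lra|].
  destruct (small_le 0 K m Hm) as [k [Hk P]]. exists k. split; auto. intros l Hl.
  apply P. rewrite Rabs_Rabsolu. auto.
Qed.

Lemma convex_on_ext a b f g : convex_on a b f -> (forall x, a <= x <= b -> g x = f x) -> convex_on a b g.
Proof.
  intros H E x y t Hx Hy Ht.
  assert (M : a <= t * x + (1 - t) * y <= b).
  { destruct Ht as [T0 T1]. split.
    - assert (t * a <= t * x) by (apply Rmult_le_compat_l; lra).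
      assert ((1 - t) * a <= (1 - t) * y) by (apply Rmult_le_compat_l; lra). lra.
    - assert (t * x <= t * b) by (apply Rmult_le_compat_l; lra).
      assert ((1 - t) * y <= (1 - t) * b) by (apply Rmult_le_compat_l; lra). lra. }
  rewrite (E _ M), (E x Hx), (E y Hy). apply H; auto.
Qed.

Lemma convex_on_affine_piece a b f A B : (forall x, a <= x <= b -> f x = A + B * (x - a)) -> convex_on a b f.
Proof.
  intros E. apply (convex_on_ext a b (fun x => (A - B * a) + B * x)).
  apply convex_on_affine. intros x Hx. rewrite E; auto. ring.
Qed.

Lemma subdiff_in_of_chord_slopes sl sh V : convex_on 0 1 V ->
  (forall x, 0 < x < 1 -> exists y y', 0 < y /\ y < y' /\ y' < x /\ sl <= chord_slope V y y') ->
  (forall x, 0 < x < 1 -> exists y y', x < y /\ y < y' /\ y' < 1 /\ chord_slope V y y' <= sh) ->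
  subdiff_in V sl sh.
Proof.
  intros Hc L R x s Hx Hs.
  split.
  - destruct (L x Hx) as [y [y' [h1 [h2 [h3 h4]]]]].
    assert (chord_slope V y y' <= chord_slope V y' x) by (apply (chord_slope_mono 0 1); auto; lra).
    specialize (Hs y' ltac:(unfold inX; lra)).
    assert (chord_slope V y' x <= s).
    { unfold chord_slope. apply (Rmult_le_reg_r (x - y')); [lra|].
      replace ((V x - V y') / (x - y') * (x - y')) with (V x - V y') by (field; lra). lra. }
    lra.
  - destruct (R x Hx) as [y [y' [h1 [h2 [h3 h4]]]]].
    assert (chord_slope V x y <= chord_slope V y y') by (apply (chord_slope_mono 0 1); auto; lra).
    specialize (Hs y ltac:(unfold inX; lra)).
    assert (s <= chord_slope V x y).
    { unfold chord_slope. apply (Rmult_le_reg_r (y - x)); [lra|].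
      replace ((V y - V x) / (y - x) * (y - x)) with (V y - V x) by (field; lra). lra. }
    lra.
Qed.

Lemma Rdiv_le_0_compat a b : 0 <= a -> 0 < b -> 0 <= a / b.
Proof. intros Ha Hb. unfold Rdiv. apply Rmult_le_pos; auto. left. apply Rinv_0_lt_compat; auto. Qed.

Definition on_chord (u : R -> R) a b := forall x, a <= x <= b -> (b - a) * u x = (b - x) * u a + (x - a) * u b.

Lemma convex_below_on_chord g f a b : convex_on 0 1 g -> 0 <= a -> a < b -> b <= 1 ->
  on_chord f a b -> g a <= f a -> g b <= f b -> forall z, a <= z <= b -> g z <= f z.
Proof.
  intros Cg h1 h2 h3 C La Lb z Hz.
  destruct (Req_dec z a) as [->|]; auto. destruct (Req_dec z b) as [->|]; auto.
  pose proof (convex_on_chord 0 1 g a z b Cg ltac:(lra) ltac:(lra) ltac:(lra) ltac:(lra)).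
  assert ((b - z) * g a <= (b - z) * f a) by (apply Rmult_le_compat_l; lra).
  assert ((z - a) * g b <= (z - a) * f b) by (apply Rmult_le_compat_l; lra).
  specialize (C z Hz). apply (Rmult_le_reg_l (b - a)); lra.
Qed.

(* The hypotheses are what
   keeps [u + l * tent] in [U] for all small [|l|]: only nodes strictly between the bounds move, the tent
   vanishes at an interior end unless [u] has slack in its slopes there ([CV0], [CV2]), and the kink at
   [x1] survives ([CV1]). *)
Section TentPerturbation.
Variables (sl sh : R) (lo hi u : R -> R).
Hypothesis Hlo : in_K lo.
Hypothesis Hhi : in_K hi.
Hypothesis Hu : CFI lo hi sl sh u.
Variables (x0 x1 x2 p1 p2 e0 e1 e2 : R).
Hypothesis h0 : 0 <= x0.
Hypothesis h01 : x0 < x1.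
Hypothesis h12 : x1 < x2.
Hypothesis h2 : x2 <= 1.
Hypothesis A1 : forall x, x0 <= x <= x1 -> u x = u x0 + p1 * (x - x0).
Hypothesis A2 : forall x, x1 <= x <= x2 -> u x = u x1 + p2 * (x - x1).
Hypothesis E0 : 0 < x0 -> e0 = 0.
Hypothesis E2 : x2 < 1 -> e2 = 0.
Hypothesis CV0 : 0 < x0 -> e1 = 0 \/ exists s, s < p1 /\ forall y, 0 <= y <= x0 -> u y >= u x0 + s * (y - x0).
Hypothesis CV1 : p1 < p2 \/ (e1 - e0) / (x1 - x0) = (e2 - e1) / (x2 - x1).
Hypothesis CV2 : x2 < 1 -> e1 = 0 \/ exists s, p2 < s /\ forall y, x2 <= y <= 1 -> u y >= u x2 + s * (y - x2).
Hypothesis S0 : e0 <> 0 -> lo x0 < u x0 < hi x0.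
Hypothesis S1 : e1 <> 0 -> lo x1 < u x1 < hi x1.
Hypothesis S2 : e2 <> 0 -> lo x2 < u x2 < hi x2.
Hypothesis HI1 : (forall x, x0 <= x <= x1 -> u x < hi x) \/
  (x0 = 0 /\ e0 = 0 /\ exists tau, p1 < tau /\ forall x, inX x -> hi x >= hi 0 + tau * x) \/ (e0 = 0 /\ e1 = 0).
Hypothesis HI2 : (forall x, x1 <= x <= x2 -> u x < hi x) \/
  (x2 = 1 /\ e2 = 0 /\ exists tau, tau < p2 /\ forall x, inX x -> hi x >= hi 1 + tau * (x - 1)) \/ (e1 = 0 /\ e2 = 0).
Hypothesis SL0 : x0 = 0 -> e0 = e1 \/ (sl < p1 /\ p1 < sh).
Hypothesis SL2 : x2 = 1 -> e1 = e2 \/ (sl < p2 /\ p2 < sh).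
Hypothesis NZ : e0 <> 0 \/ e1 <> 0 \/ e2 <> 0.

Let k1 := (e1 - e0) / (x1 - x0).
Let k2 := (e2 - e1) / (x2 - x1).

Definition tent (x : R) : R :=
  if Rlt_dec x x0 then 0 else if Rle_dec x x1 then e0 + k1 * (x - x0)
  else if Rle_dec x x2 then e1 + k2 * (x - x1) else 0.

Lemma tent_lt x : x < x0 -> tent x = 0.
Proof. intros H. unfold tent. destruct (Rlt_dec x x0); [auto|lra]. Qed.
Lemma tent_first x : x0 <= x <= x1 -> tent x = e0 + k1 * (x - x0).
Proof. intros H. unfold tent. destruct (Rlt_dec x x0); [lra|]. destruct (Rle_dec x x1); [auto|lra]. Qed.
Lemma tent_second x : x1 <= x <= x2 -> tent x = e1 + k2 * (x - x1).
Proof. intros H. unfold tent. destruct (Rlt_dec x x0); [lra|]. destruct (Rle_dec x x1).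
  - assert (x = x1) by lra. subst. unfold k1. field. lra.
  - destruct (Rle_dec x x2); [auto|lra]. Qed.
Lemma tent_gt x : x2 < x -> tent x = 0.
Proof. intros H. unfold tent. destruct (Rlt_dec x x0); [lra|]. destruct (Rle_dec x x1); [lra|].
  destruct (Rle_dec x x2); [lra|auto]. Qed.
Lemma tent_x0 : tent x0 = e0.
Proof. rewrite tent_first by lra. ring. Qed.
Lemma tent_x1 : tent x1 = e1.
Proof. rewrite tent_second by lra. ring. Qed.
Lemma tent_x2 : tent x2 = e2.
Proof. rewrite tent_second by lra. unfold k2. field. lra. Qed.

Let E := Rabs e0 + Rabs e1 + Rabs e2.

Lemma Rabs_interp_le a b c d x : a < b -> a <= x <= b -> Rabs (c + (d - c) / (b - a) * (x - a)) <= Rabs c + Rabs d.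
Proof.
  intros hab Hx.
  replace (c + (d - c) / (b - a) * (x - a)) with (((b - x) / (b - a)) * c + ((x - a) / (b - a)) * d) by (field; lra).
  eapply Rle_trans. apply Rabs_triang. rewrite !Rabs_mult.
  rewrite (Rabs_right ((b - x) / (b - a))) by (apply Rle_ge, Rdiv_le_0_compat; lra).
  rewrite (Rabs_right ((x - a) / (b - a))) by (apply Rle_ge, Rdiv_le_0_compat; lra).
  assert ((b - x) / (b - a) <= 1) by (apply (Rmult_le_reg_r (b - a)); [lra|]; field_simplify; lra).
  assert ((x - a) / (b - a) <= 1) by (apply (Rmult_le_reg_r (b - a)); [lra|]; field_simplify; lra).
  assert (0 <= (b - x) / (b - a)) by (apply Rdiv_le_0_compat; lra).
  assert (0 <= (x - a) / (b - a)) by (apply Rdiv_le_0_compat; lra).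
  pose proof (Rabs_pos c). pose proof (Rabs_pos d).
  assert ((b - x) / (b - a) * Rabs c <= 1 * Rabs c) by (apply Rmult_le_compat_r; lra).
  assert ((x - a) / (b - a) * Rabs d <= 1 * Rabs d) by (apply Rmult_le_compat_r; lra).
  lra.
Qed.

Lemma tent_bound x : Rabs (tent x) <= E.
Proof.
  unfold E. pose proof (Rabs_pos e0). pose proof (Rabs_pos e1). pose proof (Rabs_pos e2).
  destruct (Rlt_dec x x0). { rewrite tent_lt, Rabs_R0 by auto. lra. }
  destruct (Rle_dec x x1). { rewrite tent_first by lra. unfold k1. pose proof (Rabs_interp_le x0 x1 e0 e1 x h01 ltac:(lra)). lra. }
  destruct (Rle_dec x x2). { rewrite tent_second by lra. unfold k2. pose proof (Rabs_interp_le x1 x2 e1 e2 x h12 ltac:(lra)). lra. }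
  rewrite tent_gt, Rabs_R0 by lra. lra.
Qed.

Definition tent_perturb (l : R) (x : R) := u x + l * tent x.

Definition tent_admissible (l : R) : Prop :=
  (lo x0 <= u x0 + l * e0 /\ lo x1 <= u x1 + l * e1 /\ lo x2 <= u x2 + l * e2) /\
  (forall x, x0 <= x <= x1 -> tent_perturb l x <= hi x) /\
  (forall x, x1 <= x <= x2 -> tent_perturb l x <= hi x) /\
  (0 < x0 -> exists s, s <= p1 + l * k1 /\ forall y, 0 <= y <= x0 -> u y >= u x0 + s * (y - x0)) /\
  (p1 + l * k1 <= p2 + l * k2) /\
  (x2 < 1 -> exists s, p2 + l * k2 <= s /\ forall y, x2 <= y <= 1 -> u y >= u x2 + s * (y - x2)) /\
  (x0 = 0 -> sl <= p1 + l * k1 <= sh) /\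
  (x2 = 1 -> sl <= p2 + l * k2 <= sh).

Lemma tent_perturb_first l x : x0 <= x <= x1 -> tent_perturb l x = tent_perturb l x0 + (p1 + l * k1) * (x - x0).
Proof. intros H. unfold tent_perturb. rewrite tent_first, tent_x0, A1 by lra. ring. Qed.
Lemma tent_perturb_second l x : x1 <= x <= x2 -> tent_perturb l x = tent_perturb l x1 + (p2 + l * k2) * (x - x1).
Proof. intros H. unfold tent_perturb. rewrite tent_second, tent_x1, (A2 x) by lra. ring. Qed.
Lemma tent_perturb_lt l x : x < x0 -> tent_perturb l x = u x.
Proof. intros H. unfold tent_perturb. rewrite tent_lt by auto. ring. Qed.
Lemma tent_perturb_gt l x : x2 < x -> tent_perturb l x = u x.
Proof. intros H. unfold tent_perturb. rewrite tent_gt by auto. ring. Qed.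
Lemma tent_perturb_left l x : 0 < x0 -> x <= x0 -> tent_perturb l x = u x.
Proof. intros H H'. destruct (Rlt_dec x x0). apply tent_perturb_lt; auto. assert (x = x0) by lra. subst.
  unfold tent_perturb. rewrite tent_x0, E0 by auto. ring. Qed.
Lemma tent_perturb_right l x : x2 < 1 -> x2 <= x -> tent_perturb l x = u x.
Proof. intros H H'. destruct (Rlt_dec x2 x). apply tent_perturb_gt; auto. assert (x = x2) by lra. subst.
  unfold tent_perturb. rewrite tent_x2, E2 by auto. ring. Qed.

Lemma tent_perturb_convex l : tent_admissible l -> convex_on 0 1 (tent_perturb l).
Proof.
  intros [_ [_ [_ [C0 [C1 [C2 _]]]]]].
  assert (Cu : convex_on 0 1 u) by (apply convex_X_on01; apply Hu).
  assert (Cl : convex_on 0 x1 (tent_perturb l)).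
  { destruct (Rlt_dec 0 x0) as [Hx0|Hx0].
    - destruct (C0 Hx0) as [s [Hs Hsub]].
      apply (convex_on_glue 0 x0 x1 (tent_perturb l) s); [lra| |apply (convex_on_affine_piece x0 x1 _ (tent_perturb l x0) (p1 + l * k1)); apply tent_perturb_first|].
      + apply (convex_on_ext 0 x0 u). apply (convex_on_sub 0 1); auto; lra. intros x Hx. apply tent_perturb_left; lra.
      + intros y Hy. destruct (Rle_dec y x0).
        * rewrite (tent_perturb_left l y), (tent_perturb_left l x0) by lra. apply Hsub; lra.
        * rewrite (tent_perturb_first l y) by lra. assert (s * (y - x0) <= (p1 + l * k1) * (y - x0)) by (apply Rmult_le_compat_r; lra). lra.
    - assert (Ex : x0 = 0) by lra.
      apply (convex_on_affine_piece 0 x1 _ (tent_perturb l 0) (p1 + l * k1)). intros x Hx. rewrite (tent_perturb_first l x) by lra. rewrite Ex. ring. }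
  assert (Cm : convex_on 0 x2 (tent_perturb l)).
  { apply (convex_on_glue 0 x1 x2 (tent_perturb l) (p1 + l * k1)); [lra|auto| apply (convex_on_affine_piece x1 x2 _ (tent_perturb l x1) (p2 + l * k2)); apply tent_perturb_second|].
    intros y Hy. destruct (Rle_dec y x1).
    - apply (subgrad_extend_left 0 x1 x0); auto; try lra. intros z Hz. rewrite (tent_perturb_first l z), (tent_perturb_first l x1) by lra. lra.
    - rewrite (tent_perturb_second l y) by lra. assert ((p1 + l * k1) * (y - x1) <= (p2 + l * k2) * (y - x1)) by (apply Rmult_le_compat_r; lra). lra. }
  destruct (Rlt_dec x2 1) as [Hx2|Hx2].
  - destruct (C2 Hx2) as [s [Hs Hsub]].
    apply (convex_on_glue 0 x2 1 (tent_perturb l) s); [lra|auto| |].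
    + apply (convex_on_ext x2 1 u). apply (convex_on_sub 0 1); auto; lra. intros x Hx. apply tent_perturb_right; lra.
    + intros y Hy. destruct (Rle_dec y x2).
      * apply (subgrad_extend_left 0 x2 x1); auto; try lra. intros z Hz. rewrite (tent_perturb_second l z), (tent_perturb_second l x2) by lra.
        assert ((s - (p2 + l * k2)) * (x2 - z) >= 0) by (apply Rle_ge, Rmult_le_pos; lra). lra.
      * rewrite (tent_perturb_right l y), (tent_perturb_right l x2) by lra. apply Hsub; lra.
  - assert (Ex : x2 = 1) by lra. rewrite Ex in Cm. auto.
Qed.

Lemma tent_perturb_cont l : tent_admissible l -> cont_on_X (tent_perturb l).
Proof.
  intros HC. pose proof (tent_perturb_convex l HC) as Cv. destruct Hu as [[Cu _] _].
  assert (L : exists p f1, 0 < p /\ p <= x1 /\ cont_on_X f1 /\ forall x, 0 <= x <= p -> tent_perturb l x = f1 x).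
  { destruct (Rlt_dec 0 x0).
    - exists x0, u. repeat split; auto; try lra. intros x Hx. apply tent_perturb_left; lra.
    - assert (x0 = 0) by lra. exists (x1 / 2), (fun x => u x + l * ((e0 - k1 * x0) + k1 * x)).
      repeat split; try lra. apply cont_on_X_add_affine; auto.
      intros x Hx. unfold tent_perturb. rewrite tent_first by lra. ring. }
  assert (R : exists q f2, x1 < q /\ q < 1 /\ cont_on_X f2 /\ forall x, q <= x <= 1 -> tent_perturb l x = f2 x).
  { destruct (Rlt_dec x2 1).
    - exists x2, u. repeat split; auto; try lra. intros x Hx. apply tent_perturb_right; lra.
    - assert (x2 = 1) by lra. exists ((x1 + 1) / 2), (fun x => u x + l * ((e1 - k2 * x1) + k2 * x)).
      repeat split; try lra. apply cont_on_X_add_affine; auto.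
      intros x Hx. unfold tent_perturb. rewrite tent_second by lra. ring. }
  destruct L as [p [f1 [hp1 [hp2 [Cf1 Ef1]]]]]. destruct R as [q [f2 [hq1 [hq2 [Cf2 Ef2]]]]].
  apply (convex_cont_on_X_of_ends (tent_perturb l) f1 f2 p q); auto; lra.
Qed.

Lemma tent_perturb_bounds l : tent_admissible l -> forall x, inX x -> lo x <= tent_perturb l x <= hi x.
Proof.
  intros [[N0 [N1 N2]] [B1 [B2 _]]] x Hx. unfold inX in Hx.
  pose proof Hlo as [_ Clo]. apply convex_X_on01 in Clo.
  pose proof (proj1 (proj2 Hu)) as Bu.
  assert (V0 : tent_perturb l x0 = u x0 + l * e0) by (unfold tent_perturb; rewrite tent_x0; auto).
  assert (V1 : tent_perturb l x1 = u x1 + l * e1) by (unfold tent_perturb; rewrite tent_x1; auto).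
  assert (V2 : tent_perturb l x2 = u x2 + l * e2) by (unfold tent_perturb; rewrite tent_x2; auto).
  destruct (Rlt_dec x x0). { rewrite tent_perturb_lt by auto. apply Bu; unfold inX; lra. }
  destruct (Rle_dec x x1).
  { split; [|apply B1; lra].
    apply (convex_below_on_chord lo _ x0 x1); auto; try lra.
    intros z Hz. rewrite (tent_perturb_first l z), (tent_perturb_first l x1) by lra. ring. }
  destruct (Rle_dec x x2).
  { split; [|apply B2; lra].
    apply (convex_below_on_chord lo _ x1 x2); auto; try lra.
    intros z Hz. rewrite (tent_perturb_second l z), (tent_perturb_second l x2) by lra. ring. }
  rewrite tent_perturb_gt by lra. apply Bu; unfold inX; lra.
Qed.

Lemma tent_perturb_subdiff l : tent_admissible l -> subdiff_in (tent_perturb l) sl sh.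
Proof.
  intros HC. pose proof (tent_perturb_convex l HC) as Cv.
  destruct HC as [_ [_ [_ [_ [_ [_ [L0 L2]]]]]]].
  apply subdiff_in_of_chord_slopes; auto.
  - intros x Hx. destruct (Rlt_dec 0 x0).
    + set (m := Rmin x x0). assert (0 < m) by (apply Rmin_pos; lra).
      assert (m <= x) by apply Rmin_l. assert (m <= x0) by apply Rmin_r.
      exists (m / 3), (m / 2). repeat split; try lra.
      unfold chord_slope. rewrite !tent_perturb_left by lra.
      pose proof (CFI_chord_slope_bounds sl sh lo hi u (m/3) (m/2) Hu ltac:(lra) ltac:(lra) ltac:(lra)).
      unfold chord_slope in H2. lra.
    + assert (Ex : x0 = 0) by lra.
      set (m := Rmin x x1). assert (0 < m) by (apply Rmin_pos; lra).
      assert (m <= x) by apply Rmin_l. assert (m <= x1) by apply Rmin_r.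
      exists (m / 3), (m / 2). repeat split; try lra.
      unfold chord_slope. rewrite (tent_perturb_first l (m/2)), (tent_perturb_first l (m/3)) by lra.
      replace ((tent_perturb l x0 + (p1 + l * k1) * (m / 2 - x0) - (tent_perturb l x0 + (p1 + l * k1) * (m / 3 - x0))) / (m / 2 - m / 3))
        with (p1 + l * k1) by (field; lra).
      apply L0; auto.
  - intros x Hx. destruct (Rlt_dec x2 1).
    + set (m := Rmax x x2). assert (m < 1) by (apply Rmax_lub_lt; lra).
      assert (x <= m) by apply Rmax_l. assert (x2 <= m) by apply Rmax_r.
      exists ((m + 1) / 2), ((m + 3) / 4). repeat split; try lra.
      unfold chord_slope. rewrite !tent_perturb_right by lra.
      pose proof (CFI_chord_slope_bounds sl sh lo hi u ((m + 1) / 2) ((m + 3) / 4) Hu ltac:(lra) ltac:(lra) ltac:(lra)).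
      unfold chord_slope in H2. lra.
    + assert (Ex : x2 = 1) by lra.
      set (m := Rmax x x1). assert (m < 1) by (apply Rmax_lub_lt; lra).
      assert (x <= m) by apply Rmax_l. assert (x1 <= m) by apply Rmax_r.
      exists ((m + 1) / 2), ((m + 3) / 4). repeat split; try lra.
      unfold chord_slope. rewrite (tent_perturb_second l ((m + 1) / 2)), (tent_perturb_second l ((m + 3) / 4)) by lra.
      replace ((tent_perturb l x1 + (p2 + l * k2) * ((m + 3) / 4 - x1) - (tent_perturb l x1 + (p2 + l * k2) * ((m + 1) / 2 - x1))) / ((m + 3) / 4 - (m + 1) / 2))
        with (p2 + l * k2) by (field; lra).
      apply L2; auto.
Qed.

Lemma tent_perturb_CFI l : tent_admissible l -> CFI lo hi sl sh (tent_perturb l).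
Proof.
  intros HC. split; [split|split].
  - exact (tent_perturb_cont l HC).
  - apply convex_on01_X. exact (tent_perturb_convex l HC).
  - exact (tent_perturb_bounds l HC).
  - exact (tent_perturb_subdiff l HC).
Qed.

Lemma tent_slope1_0 : e0 = 0 -> e1 = 0 -> k1 = 0.
Proof. intros -> ->. unfold k1. field. lra. Qed.
Lemma tent_slope2_0 : e1 = 0 -> e2 = 0 -> k2 = 0.
Proof. intros -> ->. unfold k2. field. lra. Qed.

Lemma tent_node_small xi ei : inX xi -> (ei <> 0 -> lo xi < u xi < hi xi) ->
  small (fun l => lo xi <= u xi + l * ei).
Proof.
  intros Hxi Hs. destruct (Req_dec ei 0) as [->|Hne].
  - apply small_all. intros l. rewrite Rmult_0_r, Rplus_0_r. apply (proj1 (proj2 Hu)); auto.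
  - apply small_ge. apply Hs; auto.
Qed.

Lemma tent_perturb_le_margin l x : tent_perturb l x <= u x + Rabs l * E.
Proof.
  unfold tent_perturb. enough (l * tent x <= Rabs l * E) by lra.
  eapply Rle_trans; [apply Rle_abs|]. rewrite Rabs_mult.
  apply Rmult_le_compat_l; [apply Rabs_pos| apply tent_bound].
Qed.

Lemma tent_hi_first_small : small (fun l => forall x, x0 <= x <= x1 -> tent_perturb l x <= hi x).
Proof.
  pose proof Hu as [[Cu _] [Bu _]]. pose proof Hhi as [Chi _].
  destruct HI1 as [H|[[Hx0 [He0 [tau [Ht Htau]]]]|[He0 He1]]].
  - destruct (cont_pos_lower_bound (fun x => hi x - u x) x0 x1 (cont_on_X_minus _ _ Chi Cu))
      as [m [Hm Hmm]]; try lra.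
    { intros x Hx. specialize (H x Hx). lra. }
    apply (small_imp (fun l => Rabs l * E <= m)); [|apply small_absle; auto].
    intros l Hl x Hx. pose proof (tent_perturb_le_margin l x). specialize (Hmm x Hx). simpl in Hmm. lra.
  - apply (small_imp (fun l => p1 + l * k1 <= tau)); [|apply small_le; auto].
    intros l Hl x Hx. rewrite tent_perturb_first by auto. unfold tent_perturb. rewrite tent_x0, He0.
    rewrite Hx0 in *. specialize (Htau x ltac:(unfold inX; lra)).
    assert (u 0 <= hi 0) by (apply Bu; unfold inX; lra).
    assert ((p1 + l * k1) * (x - 0) <= tau * x)
      by (replace (x - 0) with x by ring; apply Rmult_le_compat_r; lra).
    lra.
  - apply small_all. intros l x Hx. unfold tent_perturb. rewrite tent_first by auto.
    rewrite He0, tent_slope1_0 by auto. rewrite Rmult_0_l, Rplus_0_r, Rmult_0_r, Rplus_0_r.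
    apply Bu; unfold inX; lra.
Qed.

Lemma tent_hi_second_small : small (fun l => forall x, x1 <= x <= x2 -> tent_perturb l x <= hi x).
Proof.
  pose proof Hu as [[Cu _] [Bu _]]. pose proof Hhi as [Chi _].
  destruct HI2 as [H|[[Hx2 [He2 [tau [Ht Htau]]]]|[He1 He2]]].
  - destruct (cont_pos_lower_bound (fun x => hi x - u x) x1 x2 (cont_on_X_minus _ _ Chi Cu))
      as [m [Hm Hmm]]; try lra.
    { intros x Hx. specialize (H x Hx). lra. }
    apply (small_imp (fun l => Rabs l * E <= m)); [|apply small_absle; auto].
    intros l Hl x Hx. pose proof (tent_perturb_le_margin l x). specialize (Hmm x Hx). simpl in Hmm. lra.
  - apply (small_imp (fun l => tau <= p2 + l * k2)); [|apply small_ge; auto].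
    intros l Hl x Hx.
    assert (V2 : tent_perturb l x = tent_perturb l x2 + (p2 + l * k2) * (x - x2)).
    { rewrite (tent_perturb_second l x), (tent_perturb_second l x2) by lra. ring. }
    rewrite V2. unfold tent_perturb at 1. rewrite tent_x2, He2.
    rewrite Hx2 in *. specialize (Htau x ltac:(unfold inX; lra)).
    assert (u 1 <= hi 1) by (apply Bu; unfold inX; lra).
    assert (((p2 + l * k2) - tau) * (1 - x) >= 0) by (apply Rle_ge, Rmult_le_pos; lra).
    lra.
  - apply small_all. intros l x Hx. unfold tent_perturb. rewrite tent_second by auto.
    rewrite He1, tent_slope2_0 by auto. rewrite Rmult_0_l, Rplus_0_r, Rmult_0_r, Rplus_0_r.
    apply Bu; unfold inX; lra.
Qed.

Lemma tent_left_subgrad_small : small (fun l => 0 < x0 -> exists s, s <= p1 + l * k1 /\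
  forall y, 0 <= y <= x0 -> u y >= u x0 + s * (y - x0)).
Proof.
  pose proof Hu as [[_ Cvu] _]. apply convex_X_on01 in Cvu.
  destruct (Rlt_dec 0 x0) as [Hx0|Hx0]; [|apply small_all; intros l Hc; lra].
  destruct (CV0 Hx0) as [He1|[s [Hs Hsub]]].
  - apply small_all. intros l _. exists p1. split.
    + rewrite tent_slope1_0 by auto. lra.
    + intros y Hy. apply (affine_piece_subgrad 0 1 u x0 x1 p1); auto; lra.
  - apply (small_imp (fun l => s <= p1 + l * k1)); [|apply small_ge; auto].
    intros l Hl _. exists s. auto.
Qed.

Lemma tent_right_subgrad_small : small (fun l => x2 < 1 -> exists s, p2 + l * k2 <= s /\
  forall y, x2 <= y <= 1 -> u y >= u x2 + s * (y - x2)).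
Proof.
  pose proof Hu as [[_ Cvu] _]. apply convex_X_on01 in Cvu.
  destruct (Rlt_dec x2 1) as [Hx2|Hx2]; [|apply small_all; intros l Hc; lra].
  destruct (CV2 Hx2) as [He1|[s [Hs Hsub]]].
  - apply small_all. intros l _. exists p2. split.
    + rewrite tent_slope2_0 by (auto; apply E2; auto). lra.
    + intros y Hy. rewrite (A2 x2) by lra.
      assert (u y >= u x1 + p2 * (y - x1)) by (apply (affine_piece_subgrad 0 1 u x1 x2 p2); auto; lra).
      lra.
  - apply (small_imp (fun l => p2 + l * k2 <= s)); [|apply small_le; auto].
    intros l Hl _. exists s. auto.
Qed.

Lemma tent_kink_small : small (fun l => p1 + l * k1 <= p2 + l * k2).
Proof.
  pose proof Hu as [[_ Cvu] _]. apply convex_X_on01 in Cvu.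
  destruct CV1 as [H|H].
  - apply (small_imp (fun l => (p1 - p2) + l * (k1 - k2) <= 0)); [intros l Hl; lra| apply small_le; lra].
  - assert (P12 : p1 <= p2).
    { pose proof (convex_slope_adjacent_le 0 1 u x0 x1 x2 Cvu ltac:(lra) h01 h12 ltac:(lra)).
      rewrite (A2 x2), (A1 x1) in H0 by lra.
      apply (Rmult_le_reg_r ((x1 - x0) * (x2 - x1))); [apply Rmult_lt_0_compat; lra|]. nra. }
    apply small_all. intros l. fold k1 k2 in H. rewrite H. lra.
Qed.

Lemma tent_end_slopes_small : small (fun l =>
  (x0 = 0 -> sl <= p1 + l * k1 <= sh) /\ (x2 = 1 -> sl <= p2 + l * k2 <= sh)).
Proof.
  apply small_and.
  - destruct (Req_dec x0 0) as [Hx0|Hx0]; [|apply small_all; intros l Hc; lra].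
    destruct (SL0 Hx0) as [He|[Hp1 Hp2]].
    + apply small_all. intros l _. assert (k1 = 0) by (unfold k1; rewrite He; field; lra).
      rewrite H, Rmult_0_r, Rplus_0_r. apply (CFI_affine_slope_bounds sl sh lo hi u x0 x1); auto; lra.
    + apply (small_imp (fun l => sl <= p1 + l * k1 /\ p1 + l * k1 <= sh)); [intros l Hl _; auto|].
      apply small_and; [apply small_ge| apply small_le]; lra.
  - destruct (Req_dec x2 1) as [Hx2|Hx2]; [|apply small_all; intros l Hc; lra].
    destruct (SL2 Hx2) as [He|[Hp1 Hp2]].
    + apply small_all. intros l _. assert (k2 = 0) by (unfold k2; rewrite He; field; lra).
      rewrite H, Rmult_0_r, Rplus_0_r. apply (CFI_affine_slope_bounds sl sh lo hi u x1 x2); auto; lra.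
    + apply (small_imp (fun l => sl <= p2 + l * k2 /\ p2 + l * k2 <= sh)); [intros l Hl _; auto|].
      apply small_and; [apply small_ge| apply small_le]; lra.
Qed.

Lemma tent_admissible_small : small tent_admissible.
Proof.
  assert (SN : small (fun l => lo x0 <= u x0 + l * e0 /\ lo x1 <= u x1 + l * e1 /\
                                lo x2 <= u x2 + l * e2)).
  { repeat apply small_and; apply tent_node_small; auto; unfold inX; lra. }
  pose proof tent_end_slopes_small as SS.
  unfold tent_admissible. apply small_and; [exact SN|]. apply small_and; [exact tent_hi_first_small|].
  apply small_and; [exact tent_hi_second_small|]. apply small_and; [exact tent_left_subgrad_small|].
  apply small_and; [exact tent_kink_small|]. apply small_and; [exact tent_right_subgrad_small|].
  exact SS.
Qed.

Lemma tent_not_extreme : ~ is_extreme (CFI lo hi sl sh) u.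
Proof.
  intros [_ Ext]. destruct tent_admissible_small as [k [Hk P]].
  assert (C1 := tent_perturb_CFI k (P k ltac:(rewrite Rabs_right; lra))).
  assert (C2 := tent_perturb_CFI (- k) (P (- k) ltac:(rewrite Rabs_left; lra))).
  assert (Eq := Ext (tent_perturb k) (tent_perturb (- k)) (1/2) C1 C2 ltac:(lra)).
  assert (G : forall x, inX x -> tent x = 0).
  { intros x Hx. assert (tent_perturb k x = tent_perturb (- k) x).
    { apply Eq; auto. intros y Hy. unfold tent_perturb. field. }
    unfold tent_perturb in H. assert (2 * k * tent x = 0) by lra.
    destruct (Rmult_integral _ _ H0) as [H1|H1]; [lra|auto]. }
  destruct NZ as [N|[N|N]].
  - apply N. rewrite <- tent_x0. apply G. unfold inX; lra.
  - apply N. rewrite <- tent_x1. apply G. unfold inX; lra.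
  - apply N. rewrite <- tent_x2. apply G. unfold inX; lra.
Qed.

End TentPerturbation.

Lemma convex_on_glue_subgrad v Fl Fr m0 m m' s : 0 <= m0 -> m0 < m -> m < m' -> m' <= 1 ->
  convex_on 0 m v -> convex_on 0 1 Fr ->
  (forall x, m0 <= x <= m -> v x = Fl x) -> (forall x, m <= x <= m' -> v x = Fr x) ->
  (forall y, 0 <= y <= 1 -> Fl y >= Fl m + s * (y - m)) ->
  (forall y, 0 <= y <= 1 -> Fr y >= Fr m + s * (y - m)) ->
  convex_on 0 m' v.
Proof.
  intros h0 h1 h2 h3 Cv CFr El Er Sl Sr.
  apply (convex_on_glue 0 m m' v s); [lra|auto| |].
  - apply (convex_on_ext m m' Fr); [apply (convex_on_sub 0 1); auto; lra| auto].
  - intros y Hy. destruct (Rle_dec m y).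
    + rewrite (Er y), (Er m) by lra. apply Sr; lra.
    + apply (subgrad_extend_left 0 m m0 v s Cv h0 h1); [|lra].
      intros z Hz. rewrite (El z), (El m) by lra. apply Sl; lra.
Qed.

Lemma convex_scale_sub_affine al B0 B1 u : 0 <= al -> convex_on 0 1 u -> convex_on 0 1 (fun x => al * u x - (B0 + B1 * x)).
Proof.
  intros Ha Cu x y t Hx Hy Ht. pose proof (Cu x y t Hx Hy Ht).
  assert (al * u (t * x + (1 - t) * y) <= al * (t * u x + (1 - t) * u y)) by (apply Rmult_le_compat_l; auto).
  lra.
Qed.

Lemma subgrad_scale_sub_affine al B0 B1 u m s : 0 <= al -> (forall y, 0 <= y <= 1 -> u y >= u m + s * (y - m)) ->
  forall y, 0 <= y <= 1 -> al * u y - (B0 + B1 * y) >= al * u m - (B0 + B1 * m) + (al * s - B1) * (y - m).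
Proof.
  intros Ha H y Hy. specialize (H y Hy).
  assert (al * u y >= al * (u m + s * (y - m))) by (apply Rmult_ge_compat_l; lra). lra.
Qed.

(* Conditions
   [K0]-[K2] make [hinge_comb] vanish right of [m4]; between consecutive [m_i] the perturbation is a
   positive multiple of [u] minus an affine function, so it stays convex for small [|l|]. *)
Section HingePerturbation.
Variables (sl sh : R) (lo hi u : R -> R).
Hypothesis Hlo : in_K lo.
Hypothesis Hhi : in_K hi.
Hypothesis Hu : CFI lo hi sl sh u.
Variables (m1 m2 m3 m4 s1 s2 s3 s4 c1 c2 c3 c4 : R).
Hypothesis hm : 0 < m1 /\ m1 < m2 /\ m2 < m3 /\ m3 < m4 /\ m4 < 1.
Hypothesis Hs1 : forall y, 0 <= y <= 1 -> u y >= u m1 + s1 * (y - m1).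
Hypothesis Hs2 : forall y, 0 <= y <= 1 -> u y >= u m2 + s2 * (y - m2).
Hypothesis Hs3 : forall y, 0 <= y <= 1 -> u y >= u m3 + s3 * (y - m3).
Hypothesis Hs4 : forall y, 0 <= y <= 1 -> u y >= u m4 + s4 * (y - m4).
Hypothesis Strict : forall x, m1 <= x <= m4 -> lo x < u x < hi x.
Hypothesis NA1 : ~ on_chord u m1 m2.
Hypothesis NA2 : ~ on_chord u m2 m3.
Hypothesis NA3 : ~ on_chord u m3 m4.
Let b1 := u m1 - s1 * m1.
Let b2 := u m2 - s2 * m2.
Let b3 := u m3 - s3 * m3.
Let b4 := u m4 - s4 * m4.
Hypothesis K0 : c1 + c2 + c3 + c4 = 0.
Hypothesis K1 : c1 * s1 + c2 * s2 + c3 * s3 + c4 * s4 = 0.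
Hypothesis K2 : c1 * b1 + c2 * b2 + c3 * b3 + c4 * b4 = 0.
Hypothesis KN : c1 <> 0 \/ c2 <> 0 \/ c3 <> 0.

Definition hinge (m s : R) (x : R) := if Rle_dec m x then u x - (u m + s * (x - m)) else 0.

Lemma hinge_ge m s x : m <= x -> hinge m s x = u x - (u m + s * (x - m)).
Proof. intros H. unfold hinge. destruct (Rle_dec m x); [auto|lra]. Qed.
Lemma hinge_le m s x : x <= m -> hinge m s x = 0.
Proof. intros H. unfold hinge. destruct (Rle_dec m x); [|auto]. assert (x = m) by lra. subst. ring. Qed.

Definition hinge_comb x := c1 * hinge m1 s1 x + c2 * hinge m2 s2 x + c3 * hinge m3 s3 x + c4 * hinge m4 s4 x.
Definition hinge_perturb (l : R) x := u x + l * hinge_comb x.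

Definition scale_sub_affine (al B0 B1 : R) x := al * u x - (B0 + B1 * x).

Lemma hinge_perturb_0 l x : x <= m1 -> hinge_perturb l x = u x.
Proof. intros H. unfold hinge_perturb, hinge_comb. rewrite !hinge_le by lra. ring. Qed.
Lemma hinge_perturb_1 l x : m1 <= x <= m2 -> hinge_perturb l x = scale_sub_affine (1 + l * c1) (l * c1 * b1) (l * c1 * s1) x.
Proof. intros H. unfold hinge_perturb, hinge_comb, scale_sub_affine. rewrite hinge_ge by lra. rewrite !hinge_le by lra. unfold b1. ring. Qed.
Lemma hinge_perturb_2 l x : m2 <= x <= m3 -> hinge_perturb l x = scale_sub_affine (1 + l * (c1 + c2)) (l * (c1 * b1 + c2 * b2)) (l * (c1 * s1 + c2 * s2)) x.
Proof. intros H. unfold hinge_perturb, hinge_comb, scale_sub_affine. rewrite !hinge_ge by lra. rewrite !hinge_le by lra. unfold b1, b2. ring. Qed.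
Lemma hinge_perturb_3 l x : m3 <= x <= m4 -> hinge_perturb l x = scale_sub_affine (1 + l * (c1 + c2 + c3)) (l * (c1 * b1 + c2 * b2 + c3 * b3)) (l * (c1 * s1 + c2 * s2 + c3 * s3)) x.
Proof. intros H. unfold hinge_perturb, hinge_comb, scale_sub_affine. rewrite !hinge_ge by lra. rewrite !hinge_le by lra. unfold b1, b2, b3. ring. Qed.
Lemma hinge_perturb_4 l x : m4 <= x -> hinge_perturb l x = u x.
Proof.
  intros H. unfold hinge_perturb, hinge_comb. rewrite !hinge_ge by lra.
  replace (c1 * (u x - (u m1 + s1 * (x - m1))) + c2 * (u x - (u m2 + s2 * (x - m2))) +
    c3 * (u x - (u m3 + s3 * (x - m3))) + c4 * (u x - (u m4 + s4 * (x - m4))))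
    with ((c1 + c2 + c3 + c4) * u x - ((c1 * b1 + c2 * b2 + c3 * b3 + c4 * b4) + (c1 * s1 + c2 * s2 + c3 * s3 + c4 * s4) * x))
    by (unfold b1, b2, b3, b4; ring).
  rewrite K0, K1, K2. ring.
Qed.

Definition hinge_admissible (l : R) := 0 <= 1 + l * c1 /\ 0 <= 1 + l * (c1 + c2) /\ 0 <= 1 + l * (c1 + c2 + c3) /\
  (forall x, m1 <= x <= m4 -> lo x <= hinge_perturb l x <= hi x).

Lemma hinge_perturb_convex l : hinge_admissible l -> convex_on 0 1 (hinge_perturb l).
Proof.
  intros [P1 [P2 [P3 _]]]. destruct hm as [h1 [h2 [h3 [h4 h5]]]].
  assert (Cu : convex_on 0 1 u) by (apply convex_X_on01; apply Hu).
  assert (Q0 : convex_on 0 m1 (hinge_perturb l)).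
  { apply (convex_on_ext 0 m1 u); [apply (convex_on_sub 0 1); auto; lra|]. intros x Hx. apply hinge_perturb_0; lra. }
  assert (Q1 : convex_on 0 m2 (hinge_perturb l)).
  { apply (convex_on_glue_subgrad (hinge_perturb l) u (scale_sub_affine (1 + l * c1) (l * c1 * b1) (l * c1 * s1)) 0 m1 m2 s1); auto; try lra.
    - apply convex_scale_sub_affine; auto.
    - intros x Hx. apply hinge_perturb_0; lra.
    - intros x Hx. apply hinge_perturb_1; lra.
    - intros y Hy. unfold scale_sub_affine. pose proof (subgrad_scale_sub_affine (1 + l * c1) (l * c1 * b1) (l * c1 * s1) u m1 s1 P1 Hs1 y Hy).
      replace ((1 + l * c1) * s1 - l * c1 * s1) with s1 in H by ring. exact H. }
  assert (Q2 : convex_on 0 m3 (hinge_perturb l)).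
  { apply (convex_on_glue_subgrad (hinge_perturb l) (scale_sub_affine (1 + l * c1) (l * c1 * b1) (l * c1 * s1)) (scale_sub_affine (1 + l * (c1 + c2)) (l * (c1 * b1 + c2 * b2)) (l * (c1 * s1 + c2 * s2))) m1 m2 m3 ((1 + l * c1) * s2 - l * c1 * s1)); auto; try lra.
    - apply convex_scale_sub_affine; auto.
    - intros x Hx. apply hinge_perturb_1; lra.
    - intros x Hx. apply hinge_perturb_2; lra.
    - intros y Hy. unfold scale_sub_affine. apply (subgrad_scale_sub_affine (1 + l * c1) (l * c1 * b1) (l * c1 * s1) u m2 s2 P1 Hs2 y Hy).
    - intros y Hy. unfold scale_sub_affine. pose proof (subgrad_scale_sub_affine _ (l * (c1 * b1 + c2 * b2)) (l * (c1 * s1 + c2 * s2)) u m2 s2 P2 Hs2 y Hy).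
      replace ((1 + l * (c1 + c2)) * s2 - l * (c1 * s1 + c2 * s2)) with ((1 + l * c1) * s2 - l * c1 * s1) in H by ring. exact H. }
  assert (Q3 : convex_on 0 m4 (hinge_perturb l)).
  { apply (convex_on_glue_subgrad (hinge_perturb l) (scale_sub_affine (1 + l * (c1 + c2)) (l * (c1 * b1 + c2 * b2)) (l * (c1 * s1 + c2 * s2)))
       (scale_sub_affine (1 + l * (c1 + c2 + c3)) (l * (c1 * b1 + c2 * b2 + c3 * b3)) (l * (c1 * s1 + c2 * s2 + c3 * s3))) m2 m3 m4
       ((1 + l * (c1 + c2)) * s3 - l * (c1 * s1 + c2 * s2))); auto; try lra.
    - apply convex_scale_sub_affine; auto.
    - intros x Hx. apply hinge_perturb_2; lra.
    - intros x Hx. apply hinge_perturb_3; lra.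
    - intros y Hy. unfold scale_sub_affine. apply (subgrad_scale_sub_affine _ _ _ u m3 s3 P2 Hs3 y Hy).
    - intros y Hy. unfold scale_sub_affine. pose proof (subgrad_scale_sub_affine _ (l * (c1 * b1 + c2 * b2 + c3 * b3)) (l * (c1 * s1 + c2 * s2 + c3 * s3)) u m3 s3 P3 Hs3 y Hy).
      replace ((1 + l * (c1 + c2 + c3)) * s3 - l * (c1 * s1 + c2 * s2 + c3 * s3)) with ((1 + l * (c1 + c2)) * s3 - l * (c1 * s1 + c2 * s2)) in H by ring. exact H. }
  apply (convex_on_glue_subgrad (hinge_perturb l) (scale_sub_affine (1 + l * (c1 + c2 + c3)) (l * (c1 * b1 + c2 * b2 + c3 * b3)) (l * (c1 * s1 + c2 * s2 + c3 * s3))) u m3 m4 1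
       ((1 + l * (c1 + c2 + c3)) * s4 - l * (c1 * s1 + c2 * s2 + c3 * s3))); auto; try lra.
  - intros x Hx. apply hinge_perturb_3; lra.
  - intros x Hx. apply hinge_perturb_4; lra.
  - intros y Hy. unfold scale_sub_affine. apply (subgrad_scale_sub_affine _ _ _ u m4 s4 P3 Hs4 y Hy).
  - intros y Hy. specialize (Hs4 y Hy).
    replace ((1 + l * (c1 + c2 + c3)) * s4 - l * (c1 * s1 + c2 * s2 + c3 * s3)) with s4; [lra|].
    assert (c1 + c2 + c3 = - c4) by lra. rewrite H. 
    replace (c1 * s1 + c2 * s2 + c3 * s3) with (- c4 * s4) by lra. ring.
Qed.

Lemma hinge_perturb_CFI l : hinge_admissible l -> CFI lo hi sl sh (hinge_perturb l).
Proof.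
  intros HC. pose proof (hinge_perturb_convex l HC) as Cv. destruct hm as [h1 [h2 [h3 [h4 h5]]]].
  pose proof Hu as [[Cu _] [Bu _]].
  split; [split|split].
  - apply (convex_cont_on_X_of_ends (hinge_perturb l) u u m1 m4); auto; try lra.
    + intros x Hx. apply hinge_perturb_0; lra.
    + intros x Hx. apply hinge_perturb_4; lra.
  - apply convex_on01_X; auto.
  - intros x Hx. destruct (Rle_dec x m1). { rewrite hinge_perturb_0 by auto. apply Bu; auto. }
    destruct (Rle_dec m4 x). { rewrite hinge_perturb_4 by auto. apply Bu; auto. }
    apply HC; lra.
  - apply subdiff_in_of_chord_slopes; auto.
    + intros x Hx. set (m := Rmin x m1). assert (0 < m) by (apply Rmin_pos; lra).
      assert (m <= x) by apply Rmin_l. assert (m <= m1) by apply Rmin_r.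
      exists (m / 3), (m / 2). repeat split; try lra.
      unfold chord_slope. rewrite !hinge_perturb_0 by lra.
      pose proof (CFI_chord_slope_bounds sl sh lo hi u (m/3) (m/2) Hu ltac:(lra) ltac:(lra) ltac:(lra)). unfold chord_slope in H2. lra.
    + intros x Hx. set (m := Rmax x m4). assert (m < 1) by (apply Rmax_lub_lt; lra).
      assert (x <= m) by apply Rmax_l. assert (m4 <= m) by apply Rmax_r.
      exists ((m + 1) / 2), ((m + 3) / 4). repeat split; try lra.
      unfold chord_slope. rewrite !hinge_perturb_4 by lra.
      pose proof (CFI_chord_slope_bounds sl sh lo hi u ((m + 1) / 2) ((m + 3) / 4) Hu ltac:(lra) ltac:(lra) ltac:(lra)). unfold chord_slope in H2. lra.
Qed.

Lemma hinge_bound m s x : 0 < m < 1 -> (forall y, 0 <= y <= 1 -> u y >= u m + s * (y - m)) -> 0 <= x <= 1 ->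
  Rabs (hinge m s x) <= Rabs (u 0 - (u m + s * (0 - m))) + Rabs (u 1 - (u m + s * (1 - m))).
Proof.
  intros Hm Hs Hx. pose proof (Rabs_pos (u 0 - (u m + s * (0 - m)))). pose proof (Rabs_pos (u 1 - (u m + s * (1 - m)))).
  unfold hinge. destruct (Rle_dec m x); [|rewrite Rabs_R0; lra].
  assert (Cu : convex_on 0 1 u) by (apply convex_X_on01; apply Hu).
  assert (G : 0 <= u x - (u m + s * (x - m))) by (specialize (Hs x Hx); lra).
  rewrite Rabs_right by lra.
  destruct (Req_dec x 1) as [->|]. { apply Rle_trans with (Rabs (u 1 - (u m + s * (1 - m)))); [apply Rle_abs|lra]. }
  destruct (Req_dec x 0) as [->|]. { lra. }
  pose proof (convex_on_chord 0 1 u 0 x 1 Cu ltac:(lra) ltac:(lra) ltac:(lra) ltac:(lra)).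
  pose proof (Rle_abs (u 0 - (u m + s * (0 - m)))). pose proof (Rle_abs (u 1 - (u m + s * (1 - m)))).
  assert ((1 - x) * (u 0 - (u m + s * (0 - m))) <= (1 - x) * Rabs (u 0 - (u m + s * (0 - m)))) by (apply Rmult_le_compat_l; lra).
  assert ((x - 0) * (u 1 - (u m + s * (1 - m))) <= (x - 0) * Rabs (u 1 - (u m + s * (1 - m)))) by (apply Rmult_le_compat_l; lra).
  assert ((1 - x) * Rabs (u 0 - (u m + s * (0 - m))) <= Rabs (u 0 - (u m + s * (0 - m)))) by nra.
  assert ((x - 0) * Rabs (u 1 - (u m + s * (1 - m))) <= Rabs (u 1 - (u m + s * (1 - m)))) by nra.
  nra.
Qed.

Lemma hinge_comb_bound : exists K, 0 <= K /\ forall x, 0 <= x <= 1 -> Rabs (hinge_comb x) <= K.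
Proof.
  destruct hm as [h1 [h2 [h3 [h4 h5]]]].
  set (M := fun m s => Rabs (u 0 - (u m + s * (0 - m))) + Rabs (u 1 - (u m + s * (1 - m)))).
  exists (Rabs c1 * M m1 s1 + Rabs c2 * M m2 s2 + Rabs c3 * M m3 s3 + Rabs c4 * M m4 s4).
  assert (Mp : forall m s, 0 <= M m s) by (intros; unfold M; pose proof (Rabs_pos (u 0 - (u m + s * (0 - m)))); pose proof (Rabs_pos (u 1 - (u m + s * (1 - m)))); lra).
  split.
  - pose proof (Rabs_pos c1). pose proof (Rabs_pos c2). pose proof (Rabs_pos c3). pose proof (Rabs_pos c4).
    pose proof (Mp m1 s1). pose proof (Mp m2 s2). pose proof (Mp m3 s3). pose proof (Mp m4 s4). nra.
  - intros x Hx. unfold hinge_comb.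
    assert (T : forall c m s, 0 < m < 1 -> (forall y, 0 <= y <= 1 -> u y >= u m + s * (y - m)) -> Rabs (c * hinge m s x) <= Rabs c * M m s).
    { intros c m s Hm Hs. rewrite Rabs_mult. apply Rmult_le_compat_l; [apply Rabs_pos|]. apply hinge_bound; auto. }
    pose proof (T c1 m1 s1 ltac:(lra) Hs1). pose proof (T c2 m2 s2 ltac:(lra) Hs2).
    pose proof (T c3 m3 s3 ltac:(lra) Hs3). pose proof (T c4 m4 s4 ltac:(lra) Hs4).
    pose proof (Rabs_triang (c1 * hinge m1 s1 x + c2 * hinge m2 s2 x + c3 * hinge m3 s3 x) (c4 * hinge m4 s4 x)).
    pose proof (Rabs_triang (c1 * hinge m1 s1 x + c2 * hinge m2 s2 x) (c3 * hinge m3 s3 x)).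
    pose proof (Rabs_triang (c1 * hinge m1 s1 x) (c2 * hinge m2 s2 x)). lra.
Qed.

Lemma hinge_admissible_small : small hinge_admissible.
Proof.
  destruct hm as [h1 [h2 [h3 [h4 h5]]]].
  pose proof Hu as [[Cu _] _]. pose proof Hlo as [Cl _]. pose proof Hhi as [Ch _].
  destruct hinge_comb_bound as [K [HK PK]].
  destruct (cont_pos_lower_bound (fun x => u x - lo x) m1 m4 (cont_on_X_minus _ _ Cu Cl) ltac:(lra) ltac:(lra) ltac:(lra)) as [ml [Hml Pml]].
  { intros x Hx. specialize (Strict x Hx). lra. }
  destruct (cont_pos_lower_bound (fun x => hi x - u x) m1 m4 (cont_on_X_minus _ _ Ch Cu) ltac:(lra) ltac:(lra) ltac:(lra)) as [mh [Hmh Pmh]].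
  { intros x Hx. specialize (Strict x Hx). lra. }
  assert (SB : small (fun l => forall x, m1 <= x <= m4 -> lo x <= hinge_perturb l x <= hi x)).
  { apply (small_imp (fun l => Rabs l * K <= Rmin ml mh)); [|apply small_absle; apply Rmin_pos; auto].
    intros l Hl x Hx. specialize (Pml x Hx). specialize (Pmh x Hx). simpl in Pml, Pmh.
    assert (A : Rabs (l * hinge_comb x) <= Rabs l * K) by (rewrite Rabs_mult; apply Rmult_le_compat_l; [apply Rabs_pos| apply PK; lra]).
    pose proof (Rmin_l ml mh). pose proof (Rmin_r ml mh). pose proof (Rle_abs (l * hinge_comb x)) as R1. pose proof (Rle_abs (- (l * hinge_comb x))) as R2. rewrite Rabs_Ropp in R2. unfold hinge_perturb. lra. }
  unfold hinge_admissible. apply small_and; [apply small_ge; lra|]. apply small_and; [apply small_ge; lra|].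
  apply small_and; [apply small_ge; lra| exact SB].
Qed.

Lemma on_chord_of_slope a b s : a < b -> (forall x, a <= x <= b -> u x = u a + s * (x - a)) -> on_chord u a b.
Proof. intros Hab H x Hx. rewrite (H x Hx), (H b) by lra. ring. Qed.

Lemma hinge_comb_nonzero : exists x, 0 <= x <= 1 /\ hinge_comb x <> 0.
Proof.
  destruct hm as [h1 [h2 [h3 [h4 h5]]]].
  assert (Gen : forall a b c s, m1 <= a -> a < b -> b <= m4 -> ~ on_chord u a b -> c <> 0 ->
     (forall x, a <= x <= b -> hinge_comb x = c * (u x - (u a + s * (x - a)))) -> exists x, 0 <= x <= 1 /\ hinge_comb x <> 0).
  { intros a b c s ha hab hb NA Hc Hp. apply NNPP. intro N. apply NA. apply (on_chord_of_slope a b s hab).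
    intros x Hx. assert (hinge_comb x = 0) by (apply NNPP; intro; apply N; exists x; split; auto; lra).
    rewrite (Hp x Hx) in H. destruct (Rmult_integral _ _ H); [lra|]. lra. }
  destruct (Req_dec c1 0) as [E1|E1].
  - destruct (Req_dec c2 0) as [E2|E2].
    + destruct KN as [|[|N3]]; try contradiction.
      apply (Gen m3 m4 c3 s3); auto; try lra.
      intros x Hx. unfold hinge_comb. rewrite E1, E2, (hinge_ge m3), (hinge_le m4) by lra. ring.
    + apply (Gen m2 m3 c2 s2); auto; try lra.
      intros x Hx. unfold hinge_comb. rewrite E1, (hinge_ge m2), (hinge_le m3), (hinge_le m4) by lra. ring.
  - apply (Gen m1 m2 c1 s1); auto; try lra.
    intros x Hx. unfold hinge_comb. rewrite (hinge_ge m1), (hinge_le m2), (hinge_le m3), (hinge_le m4) by lra. ring.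
Qed.

Lemma hinge_not_extreme : ~ is_extreme (CFI lo hi sl sh) u.
Proof.
  intros [_ Ext]. destruct hinge_admissible_small as [k [Hk P]].
  assert (C1 := hinge_perturb_CFI k (P k ltac:(rewrite Rabs_right; lra))).
  assert (C2 := hinge_perturb_CFI (- k) (P (- k) ltac:(rewrite Rabs_left; lra))).
  assert (Eq := Ext (hinge_perturb k) (hinge_perturb (- k)) (1/2) C1 C2 ltac:(lra)).
  destruct hinge_comb_nonzero as [x [Hx Nz]]. apply Nz.
  assert (hinge_perturb k x = hinge_perturb (- k) x).
  { apply Eq; [|unfold inX; lra]. intros y Hy. unfold hinge_perturb. field. }
  unfold hinge_perturb in H. assert (2 * k * hinge_comb x = 0) by lra.
  destruct (Rmult_integral _ _ H0) as [H1|H1]; [lra|auto].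
Qed.

End HingePerturbation.

Lemma subgrad_neq_of_not_on_chord u a b sa sb : convex_on 0 1 u -> 0 <= a -> a < b -> b <= 1 -> ~ on_chord u a b ->
  (forall y, 0 <= y <= 1 -> u y >= u a + sa * (y - a)) ->
  (forall y, 0 <= y <= 1 -> u y >= u b + sb * (y - b)) -> sa <> sb.
Proof.
  intros Cu h1 h2 h3 NA Ha Hb E. subst sb. apply NA. intros x Hx.
  pose proof (Ha b ltac:(lra)). pose proof (Hb a ltac:(lra)).
  assert (Eb : u b = u a + sa * (b - a)) by lra.
  destruct (Req_dec x a) as [->|]. { ring. }
  destruct (Req_dec x b) as [->|]. { ring. }
  pose proof (convex_on_chord 0 1 u a x b Cu ltac:(lra) ltac:(lra) ltac:(lra) ltac:(lra)).
  pose proof (Ha x ltac:(lra)).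
  rewrite Eb in *.
  assert ((b - a) * u x >= (b - a) * (u a + sa * (x - a))) by (apply Rmult_ge_compat_l; lra).
  lra.
Qed.

Lemma not_extreme_of_kinks sl sh lo hi u m1 m2 m3 m4 : in_K lo -> in_K hi -> CFI lo hi sl sh u ->
  0 < m1 -> m1 < m2 -> m2 < m3 -> m3 < m4 -> m4 < 1 ->
  (forall x, m1 <= x <= m4 -> lo x < u x < hi x) ->
  ~ on_chord u m1 m2 -> ~ on_chord u m2 m3 -> ~ on_chord u m3 m4 ->
  ~ is_extreme (CFI lo hi sl sh) u.
Proof.
  intros Hlo Hhi Hu h1 h2 h3 h4 h5 St N1 N2 N3.
  assert (Cu : convex_on 0 1 u) by (apply convex_X_on01; apply Hu).
  destruct (convex_subgrad_exists u m1 Cu ltac:(lra)) as [s1 S1].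
  destruct (convex_subgrad_exists u m2 Cu ltac:(lra)) as [s2 S2].
  destruct (convex_subgrad_exists u m3 Cu ltac:(lra)) as [s3 S3].
  destruct (convex_subgrad_exists u m4 Cu ltac:(lra)) as [s4 S4].
  set (b1 := u m1 - s1 * m1). set (b2 := u m2 - s2 * m2). set (b3 := u m3 - s3 * m3). set (b4 := u m4 - s4 * m4).
  set (D := fun si sj sk bi bj bk => (sj - si) * (bk - bi) - (sk - si) * (bj - bi)).
  assert (s23 : s2 <> s3) by (apply (subgrad_neq_of_not_on_chord u m2 m3); auto; lra).
  assert (HM : 0 < m1 /\ m1 < m2 /\ m2 < m3 /\ m3 < m4 /\ m4 < 1) by lra.
  intro Ext.
  (* The coefficients [c_i] solve [K0]-[K2] by Cramer's rule; if the leading minor vanishes a solution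
     with [c4 = 0] exists. *)
  destruct (Req_dec (D s1 s2 s3 b1 b2 b3) 0) as [Z|NZ].
  - refine (hinge_not_extreme sl sh lo hi u Hlo Hhi Hu m1 m2 m3 m4 s1 s2 s3 s4 (s3 - s2) (s1 - s3) (s2 - s1) 0 HM S1 S2 S3 S4 St N1 N2 N3 _ _ _ _ Ext).
    + ring.
    + ring.
    + unfold D, b1, b2, b3 in Z. lra.
    + left. lra.
  - set (c1 := D s2 s3 s4 b2 b3 b4). set (c2 := - D s1 s3 s4 b1 b3 b4).
    set (c3 := D s1 s2 s4 b1 b2 b4). set (c4 := - D s1 s2 s3 b1 b2 b3).
    assert (K0 : c1 + c2 + c3 + c4 = 0) by (unfold c1, c2, c3, c4, D; ring).
    refine (hinge_not_extreme sl sh lo hi u Hlo Hhi Hu m1 m2 m3 m4 s1 s2 s3 s4 c1 c2 c3 c4 HM S1 S2 S3 S4 St N1 N2 N3 K0 _ _ _ Ext).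
    + unfold c1, c2, c3, c4, D; ring.
    + unfold c1, c2, c3, c4, D, b1, b2, b3, b4; ring.
    + destruct (Req_dec c1 0); [|left; auto]. destruct (Req_dec c2 0); [|right; left; auto].
      destruct (Req_dec c3 0); [|right; right; auto]. exfalso. apply NZ. unfold c4 in K0. lra.
Qed.

(** * Maximal affine pieces of the strict region *)

Lemma not_on_chord_shrink_left u a b : cont_on_X u -> convex_on 0 1 u -> 0 <= a -> a < b -> b <= 1 -> ~ on_chord u a b ->
  exists a', a < a' < b /\ ~ on_chord u a' b.
Proof.
  intros Cc Cu h1 h2 h3 NA.
  assert (Ex : exists z, a < z < b /\ (b - a) * u z < (b - z) * u a + (z - a) * u b).
  { apply NNPP. intro N. apply NA. intros x Hx.
    destruct (Req_dec x a) as [->|]. { ring. } destruct (Req_dec x b) as [->|]. { ring. }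
    pose proof (convex_on_chord 0 1 u a x b Cu ltac:(lra) ltac:(lra) ltac:(lra) ltac:(lra)).
    destruct H1; [|auto]. exfalso. apply N. exists x. split; [lra|auto]. }
  destruct Ex as [z [Hz G]].
  set (Gp := (b - z) * u a + (z - a) * u b - (b - a) * u z).
  assert (HG : 0 < Gp) by (unfold Gp; lra).
  destruct (Cc a ltac:(unfold inX; lra) (Gp / (4 * (b - z))) ltac:(apply Rdiv_lt_0_compat; lra)) as [del [Hd Hdel]].
  set (M := Rabs (u b) + Rabs (u z) + 1).
  assert (HM : 0 < M) by (unfold M; pose proof (Rabs_pos (u b)); pose proof (Rabs_pos (u z)); lra).
  set (h := Rmin (Rmin ((z - a) / 2) (del / 2)) (Gp / (4 * M))).
  assert (hp : 0 < h) by (unfold h; repeat apply Rmin_pos; try lra; apply Rdiv_lt_0_compat; lra).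
  assert (h1' : h <= (z - a) / 2) by (unfold h; eapply Rle_trans; [apply Rmin_l| apply Rmin_l]).
  assert (h2' : h <= del / 2) by (unfold h; eapply Rle_trans; [apply Rmin_l| apply Rmin_r]).
  assert (h3' : h <= Gp / (4 * M)) by (unfold h; apply Rmin_r).
  exists (a + h). split; [lra|]. intro C.
  specialize (C z ltac:(lra)).
  specialize (Hdel (a + h) ltac:(unfold inX; lra) ltac:(rewrite Rabs_right; lra)).
  apply Rabs_def2 in Hdel.
  assert (A1 : (b - z) * (u (a + h) - u a) >= - ((b - z) * (Gp / (4 * (b - z))))).
  { assert ((b - z) * (u (a + h) - u a) >= (b - z) * (- (Gp / (4 * (b - z))))) by (apply Rmult_ge_compat_l; lra). lra. }
  replace ((b - z) * (Gp / (4 * (b - z)))) with (Gp / 4) in A1 by (field; lra).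
  assert (A2 : h * (u b - u z) <= h * M).
  { apply Rmult_le_compat_l; [lra|]. unfold M. pose proof (Rle_abs (u b)) as R1. pose proof (Rle_abs (- u z)) as R2. rewrite Rabs_Ropp in R2. lra. }
  assert (A3 : h * M <= Gp / 4).
  { apply (Rmult_le_compat_r M) in h3'; [|lra]. replace (Gp / (4 * M) * M) with (Gp / 4) in h3' by (field; lra). lra. }
  unfold Gp in *. lra.
Qed.

Lemma not_on_chord_shrink_right u a b : cont_on_X u -> convex_on 0 1 u -> 0 <= a -> a < b -> b <= 1 -> ~ on_chord u a b ->
  exists b', a < b' < b /\ ~ on_chord u a b'.
Proof.
  intros Cc Cu h1 h2 h3 NA.
  assert (Ex : exists z, a < z < b /\ (b - a) * u z < (b - z) * u a + (z - a) * u b).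
  { apply NNPP. intro N. apply NA. intros x Hx.
    destruct (Req_dec x a) as [->|]. { ring. } destruct (Req_dec x b) as [->|]. { ring. }
    pose proof (convex_on_chord 0 1 u a x b Cu ltac:(lra) ltac:(lra) ltac:(lra) ltac:(lra)).
    destruct H1; [|auto]. exfalso. apply N. exists x. split; [lra|auto]. }
  destruct Ex as [z [Hz G]].
  set (Gp := (b - z) * u a + (z - a) * u b - (b - a) * u z).
  assert (HG : 0 < Gp) by (unfold Gp; lra).
  destruct (Cc b ltac:(unfold inX; lra) (Gp / (4 * (z - a))) ltac:(apply Rdiv_lt_0_compat; lra)) as [del [Hd Hdel]].
  set (M := Rabs (u a) + Rabs (u z) + 1).
  assert (HM : 0 < M) by (unfold M; pose proof (Rabs_pos (u a)); pose proof (Rabs_pos (u z)); lra).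
  set (h := Rmin (Rmin ((b - z) / 2) (del / 2)) (Gp / (4 * M))).
  assert (hp : 0 < h) by (unfold h; repeat apply Rmin_pos; try lra; apply Rdiv_lt_0_compat; lra).
  assert (h1' : h <= (b - z) / 2) by (unfold h; eapply Rle_trans; [apply Rmin_l| apply Rmin_l]).
  assert (h2' : h <= del / 2) by (unfold h; eapply Rle_trans; [apply Rmin_l| apply Rmin_r]).
  assert (h3' : h <= Gp / (4 * M)) by (unfold h; apply Rmin_r).
  exists (b - h). split; [lra|]. intro C.
  specialize (C z ltac:(lra)).
  specialize (Hdel (b - h) ltac:(unfold inX; lra) ltac:(rewrite Rabs_left; lra)).
  apply Rabs_def2 in Hdel.
  assert (A1 : (z - a) * (u (b - h) - u b) >= - ((z - a) * (Gp / (4 * (z - a))))).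
  { assert ((z - a) * (u (b - h) - u b) >= (z - a) * (- (Gp / (4 * (z - a))))) by (apply Rmult_ge_compat_l; lra). lra. }
  replace ((z - a) * (Gp / (4 * (z - a)))) with (Gp / 4) in A1 by (field; lra).
  assert (A2 : h * (u a - u z) <= h * M).
  { apply Rmult_le_compat_l; [lra|]. unfold M. pose proof (Rle_abs (u a)) as R1. pose proof (Rle_abs (- u z)) as R2. rewrite Rabs_Ropp in R2. lra. }
  assert (A3 : h * M <= Gp / 4).
  { apply (Rmult_le_compat_r M) in h3'; [|lra]. replace (Gp / (4 * M) * M) with (Gp / 4) in h3' by (field; lra). lra. }
  unfold Gp in *. lra.
Qed.

Definition line_on (u : R -> R) al be a b := forall x, a <= x <= b -> u x = al + be * x.

Lemma line_on_of_on_chord u a b : a < b -> on_chord u a b -> exists al be, line_on u al be a b.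
Proof.
  intros hab C. exists (u a - (u b - u a) / (b - a) * a), ((u b - u a) / (b - a)).
  intros x Hx. specialize (C x Hx).
  apply (Rmult_eq_reg_l (b - a)); [|lra]. rewrite C. field. lra.
Qed.

Lemma on_chord_of_line_on u al be a b : line_on u al be a b -> on_chord u a b.
Proof. intros L x Hx. rewrite (L x Hx), (L a), (L b) by lra. ring. Qed.

Lemma line_on_sub u al be a b a' b' : line_on u al be a b -> a <= a' -> b' <= b -> line_on u al be a' b'.
Proof. intros L h1 h2 x Hx. apply L; lra. Qed.

Lemma line_on_unique u al be al' be' a b a' b' o1 o2 : line_on u al be a b -> line_on u al' be' a' b' ->
  a <= o1 <= b -> a' <= o1 <= b' -> a <= o2 <= b -> a' <= o2 <= b' -> o1 < o2 -> al = al' /\ be = be'.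
Proof.
  intros L1 L2 h1 h2 h3 h4 h5.
  pose proof (L1 o1 h1). pose proof (L2 o1 h2). pose proof (L1 o2 h3). pose proof (L2 o2 h4).
  assert (be * (o2 - o1) = be' * (o2 - o1)) by lra.
  apply Rmult_eq_reg_r in H3; [|lra]. subst. split; lra.
Qed.

Lemma line_on_right_closed u al be a b : cont_on_X u -> 0 <= a -> a < b -> b <= 1 ->
  (forall x, a <= x < b -> u x = al + be * x) -> u b = al + be * b.
Proof.
  intros Cu h1 h2 h3 H. apply NNPP. intro N.
  set (eps := Rabs (u b - (al + be * b)) / 2).
  assert (He : 0 < eps) by (unfold eps; assert (0 < Rabs (u b - (al + be * b))) by (apply Rabs_pos_lt; lra); lra).
  destruct (Cu b ltac:(unfold inX; lra) eps He) as [del [Hd Hdel]].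
  set (h := Rmin (Rmin (del / 2) ((b - a) / 2)) (eps / (Rabs be + 1))).
  assert (hp : 0 < h) by (unfold h; repeat apply Rmin_pos; try lra; apply Rdiv_lt_0_compat; [lra| pose proof (Rabs_pos be); lra]).
  assert (h1' : h <= del / 2) by (unfold h; eapply Rle_trans; [apply Rmin_l| apply Rmin_l]).
  assert (h2' : h <= (b - a) / 2) by (unfold h; eapply Rle_trans; [apply Rmin_l| apply Rmin_r]).
  assert (h3' : h <= eps / (Rabs be + 1)) by (unfold h; apply Rmin_r).
  specialize (Hdel (b - h) ltac:(unfold inX; lra) ltac:(rewrite Rabs_left; lra)).
  rewrite (H (b - h)) in Hdel by lra.
  assert (A : Rabs be * h < eps).
  { apply Rlt_le_trans with ((Rabs be + 1) * h); [pose proof (Rabs_pos be); nra|].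
    apply (Rmult_le_compat_l (Rabs be + 1)) in h3'; [|pose proof (Rabs_pos be); lra].
    replace ((Rabs be + 1) * (eps / (Rabs be + 1))) with eps in h3' by (field; pose proof (Rabs_pos be); lra). lra. }
  assert (Rabs (u b - (al + be * b)) <= Rabs (al + be * (b - h) - u b) + Rabs be * h).
  { replace (u b - (al + be * b)) with (- (al + be * (b - h) - u b) + (- be) * h) by ring.
    eapply Rle_trans; [apply Rabs_triang|]. rewrite Rabs_Ropp, Rabs_mult, Rabs_Ropp, (Rabs_right h) by lra. lra. }
  unfold eps in *. lra.
Qed.

Lemma line_on_left_closed u al be a b : cont_on_X u -> 0 <= a -> a < b -> b <= 1 ->
  (forall x, a < x <= b -> u x = al + be * x) -> u a = al + be * a.
Proof.
  intros Cu h1 h2 h3 H. apply NNPP. intro N.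
  set (eps := Rabs (u a - (al + be * a)) / 2).
  assert (He : 0 < eps) by (unfold eps; assert (0 < Rabs (u a - (al + be * a))) by (apply Rabs_pos_lt; lra); lra).
  destruct (Cu a ltac:(unfold inX; lra) eps He) as [del [Hd Hdel]].
  set (h := Rmin (Rmin (del / 2) ((b - a) / 2)) (eps / (Rabs be + 1))).
  assert (hp : 0 < h) by (unfold h; repeat apply Rmin_pos; try lra; apply Rdiv_lt_0_compat; [lra| pose proof (Rabs_pos be); lra]).
  assert (h1' : h <= del / 2) by (unfold h; eapply Rle_trans; [apply Rmin_l| apply Rmin_l]).
  assert (h2' : h <= (b - a) / 2) by (unfold h; eapply Rle_trans; [apply Rmin_l| apply Rmin_r]).
  assert (h3' : h <= eps / (Rabs be + 1)) by (unfold h; apply Rmin_r).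
  specialize (Hdel (a + h) ltac:(unfold inX; lra) ltac:(rewrite Rabs_right; lra)).
  rewrite (H (a + h)) in Hdel by lra.
  assert (A : Rabs be * h < eps).
  { apply Rlt_le_trans with ((Rabs be + 1) * h); [pose proof (Rabs_pos be); nra|].
    apply (Rmult_le_compat_l (Rabs be + 1)) in h3'; [|pose proof (Rabs_pos be); lra].
    replace ((Rabs be + 1) * (eps / (Rabs be + 1))) with eps in h3' by (field; pose proof (Rabs_pos be); lra). lra. }
  assert (Rabs (u a - (al + be * a)) <= Rabs (al + be * (a + h) - u a) + Rabs be * h).
  { replace (u a - (al + be * a)) with (- (al + be * (a + h) - u a) + be * h) by ring.
    eapply Rle_trans; [apply Rabs_triang|]. rewrite Rabs_Ropp, Rabs_mult, (Rabs_right h) by lra. lra. }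
  unfold eps in *. lra.
Qed.

Section StrictPieces.
Variables (sl sh : R) (lo hi u : R -> R).
Hypothesis Hlo : in_K lo.
Hypothesis Hhi : in_K hi.
Hypothesis Hu : CFI lo hi sl sh u.
Hypothesis Ext : is_extreme (CFI lo hi sl sh) u.

Definition strict_between x := lo x < u x < hi x.

Lemma strict_between_nbhd x : inX x -> strict_between x -> exists eta, 0 < eta /\ forall y, inX y -> Rabs (y - x) <= eta -> strict_between y.
Proof.
  intros Hx [S1 S2]. pose proof Hu as [[Cu _] _]. pose proof Hlo as [Cl _]. pose proof Hhi as [Ch _].
  destruct (cont_on_X_minus _ _ Cu Cl x Hx (u x - lo x) ltac:(lra)) as [d1 [Hd1 P1]].
  destruct (cont_on_X_minus _ _ Ch Cu x Hx (hi x - u x) ltac:(lra)) as [d2 [Hd2 P2]].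
  exists (Rmin d1 d2 / 2). split; [apply Rdiv_lt_0_compat; [apply Rmin_pos; auto| lra]|].
  intros y Hy Hyx. pose proof (Rmin_l d1 d2). pose proof (Rmin_r d1 d2).
  specialize (P1 y Hy ltac:(lra)). specialize (P2 y Hy ltac:(lra)).
  apply Rabs_def2 in P1. apply Rabs_def2 in P2. unfold strict_between. lra.
Qed.

(* If [u] were on no chord [x, x + e], three nested intervals on which it is not affine would give
   four kinks of [u] where [lo < u < hi]. *)
Lemma strict_chord_right x : 0 <= x < 1 -> strict_between x ->
  exists e, 0 < e /\ x + e <= 1 /\ on_chord u x (x + e) /\ forall y, x <= y <= x + e -> strict_between y.
Proof.
  intros Hx Sx. destruct (strict_between_nbhd x ltac:(unfold inX; lra) Sx) as [eta [He Pe]].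
  pose proof Hu as [[Cu Cvu] _]. apply convex_X_on01 in Cvu.
  set (e := Rmin eta ((1 - x) / 2)).
  assert (ep : 0 < e) by (apply Rmin_pos; lra).
  assert (e1 : e <= eta) by apply Rmin_l. assert (e2 : e <= (1 - x) / 2) by apply Rmin_r.
  assert (St : forall y, x <= y <= x + e -> strict_between y).
  { intros y Hy. apply Pe. unfold inX; lra. rewrite Rabs_right; lra. }
  destruct (classic (exists e', 0 < e' <= e /\ on_chord u x (x + e'))) as [[e' [He' C]]|N].
  - exists e'. split; [lra|]. split; [lra|]. split; [auto|]. intros y Hy. apply St; lra.
  - exfalso.
    assert (NC : forall e', 0 < e' <= e -> ~ on_chord u x (x + e')) by (intros e' H' C; apply N; exists e'; auto).
    destruct (not_on_chord_shrink_left u x (x + e) Cu Cvu ltac:(lra) ltac:(lra) ltac:(lra) (NC e ltac:(lra))) as [a1 [Ha1 N1]].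
    destruct (not_on_chord_shrink_left u x a1 Cu Cvu ltac:(lra) ltac:(lra) ltac:(lra)) as [a2 [Ha2 N2]].
    { replace a1 with (x + (a1 - x)) by ring. apply NC; lra. }
    destruct (not_on_chord_shrink_left u x a2 Cu Cvu ltac:(lra) ltac:(lra) ltac:(lra)) as [a3 [Ha3 N3]].
    { replace a2 with (x + (a2 - x)) by ring. apply NC; lra. }
    apply (not_extreme_of_kinks sl sh lo hi u a3 a2 a1 (x + e) Hlo Hhi Hu); auto; try lra.
    intros y Hy. apply St; lra.
Qed.

Lemma strict_chord_left x : 0 < x <= 1 -> strict_between x ->
  exists e, 0 < e /\ 0 <= x - e /\ on_chord u (x - e) x /\ forall y, x - e <= y <= x -> strict_between y.
Proof.
  intros Hx Sx. destruct (strict_between_nbhd x ltac:(unfold inX; lra) Sx) as [eta [He Pe]].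
  pose proof Hu as [[Cu Cvu] _]. apply convex_X_on01 in Cvu.
  set (e := Rmin eta (x / 2)).
  assert (ep : 0 < e) by (apply Rmin_pos; lra).
  assert (e1 : e <= eta) by apply Rmin_l. assert (e2 : e <= x / 2) by apply Rmin_r.
  assert (St : forall y, x - e <= y <= x -> strict_between y).
  { intros y Hy. apply Pe. unfold inX; lra. rewrite Rabs_left1; lra. }
  destruct (classic (exists e', 0 < e' <= e /\ on_chord u (x - e') x)) as [[e' [He' C]]|N].
  - exists e'. split; [lra|]. split; [lra|]. split; [auto|]. intros y Hy. apply St; lra.
  - exfalso.
    assert (NC : forall e', 0 < e' <= e -> ~ on_chord u (x - e') x) by (intros e' H' C; apply N; exists e'; auto).
    destruct (not_on_chord_shrink_right u (x - e) x Cu Cvu ltac:(lra) ltac:(lra) ltac:(lra) (NC e ltac:(lra))) as [b1 [Hb1 N1]].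
    destruct (not_on_chord_shrink_right u b1 x Cu Cvu ltac:(lra) ltac:(lra) ltac:(lra)) as [b2 [Hb2 N2]].
    { replace b1 with (x - (x - b1)) by ring. apply NC; lra. }
    destruct (not_on_chord_shrink_right u b2 x Cu Cvu ltac:(lra) ltac:(lra) ltac:(lra)) as [b3 [Hb3 N3]].
    { replace b2 with (x - (x - b2)) by ring. apply NC; lra. }
    apply (not_extreme_of_kinks sl sh lo hi u (x - e) b1 b2 b3 Hlo Hhi Hu); auto; try lra.
    intros y Hy. apply St; lra.
Qed.

Definition strict_segment c d := 0 <= c /\ c < d /\ d <= 1 /\ on_chord u c d /\ forall x, c < x < d -> strict_between x.
Definition max_piece c d := strict_segment c d /\ (forall e, 0 < e -> ~ strict_segment (c - e) d) /\ (forall e, 0 < e -> ~ strict_segment c (d + e)).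

Lemma on_chord_sub a b a' b' : a < b -> on_chord u a b -> a <= a' -> a' < b' -> b' <= b -> on_chord u a' b'.
Proof.
  intros hab C h1 h2 h3. destruct (line_on_of_on_chord u a b hab C) as [al [be L]].
  apply (on_chord_of_line_on u al be). apply (line_on_sub u al be a b); auto.
Qed.

Lemma strict_segment_sub c d c' d' : strict_segment c d -> c <= c' -> c' < d' -> d' <= d ->
  strict_segment c' d'.
Proof.
  intros [h1 [h2 [h3 [C St]]]] k1 k2 k3. split; [lra|split; [lra|split; [lra|split]]].
  - apply (on_chord_sub c d); auto.
  - intros x Hx. apply St; lra.
Qed.

Lemma strict_segment_extend_right c0 d0 : strict_segment c0 d0 ->
  exists d, d0 <= d /\ strict_segment c0 d /\ forall e, 0 < e -> ~ strict_segment c0 (d + e).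
Proof.
  intros S0. pose proof Hu as [[Cu _] _]. pose proof S0 as [h1 [h2 [h3 [C0 _]]]].
  destruct (line_on_of_on_chord u c0 d0 h2 C0) as [al [be L0]].
  set (ER := fun d => d0 <= d /\ strict_segment c0 d).
  assert (ERb : bound ER) by (exists 1; intros d [_ [_ [_ [H _]]]]; auto).
  destruct (completeness ER ERb (ex_intro _ d0 (conj (Rle_refl d0) S0))) as [D [UbD LubD]].
  assert (hD0 : d0 <= D) by (apply UbD; split; [lra|exact S0]).
  assert (hD1 : D <= 1) by (apply LubD; intros d [_ [_ [_ [H _]]]]; auto).
  assert (LineR : forall d, ER d -> line_on u al be c0 d).
  { intros d [Hd [_ [Hcd [_ [Cd _]]]]]. destruct (line_on_of_on_chord u c0 d Hcd Cd) as [al' [be' L']].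
    destruct (line_on_unique u al be al' be' c0 d0 c0 d c0 d0) as [-> ->]; auto; lra. }
  assert (Below : forall x, x < D -> exists d, ER d /\ x < d).
  { intros x Hx. apply NNPP. intro N. assert (D <= x); [|lra].
    apply LubD. intros d Ed. apply Rnot_lt_le. intro. apply N. exists d; auto. }
  exists D. split; [lra|split].
  - split; [lra|split; [lra|split; [lra|split]]].
    + apply (on_chord_of_line_on u al be). intros x Hx.
      destruct (Rlt_dec x D).
      * destruct (Below x r) as [d [Ed Hxd]]. apply (LineR d Ed). lra.
      * replace x with D by lra. apply (line_on_right_closed u al be c0 D Cu); try lra.
        intros x' Hx'. destruct (Below x' ltac:(lra)) as [d [Ed Hxd]]. apply (LineR d Ed). lra.
    + intros x Hx. destruct (Below x ltac:(lra)) as [d [[_ [_ [_ [_ [_ Sd]]]]] Hxd]]. apply Sd. lra.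
  - intros e He S. assert (D + e <= D) by (apply UbD; split; [lra|auto]). lra.
Qed.

(* The left extension is the right one in the reflected variable [- c]. *)
Lemma strict_segment_extend_left c0 d0 : strict_segment c0 d0 ->
  exists c, c <= c0 /\ strict_segment c d0 /\ forall e, 0 < e -> ~ strict_segment (c - e) d0.
Proof.
  intros S0. pose proof Hu as [[Cu _] _]. pose proof S0 as [h1 [h2 [h3 [C0 _]]]].
  destruct (line_on_of_on_chord u c0 d0 h2 C0) as [al [be L0]].
  set (EL := fun t => - t <= c0 /\ strict_segment (- t) d0).
  assert (ELb : bound EL) by (exists 0; intros t [_ [H _]]; lra).
  assert (EL0 : EL (- c0)) by (split; [lra| rewrite Ropp_involutive; auto]).
  destruct (completeness EL ELb (ex_intro _ _ EL0)) as [T [UbT LubT]].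
  assert (hT0 : - c0 <= T) by (apply UbT; auto).
  assert (hT1 : T <= 0) by (apply LubT; intros t [_ [H _]]; lra).
  assert (LineL : forall t, EL t -> line_on u al be (- t) d0).
  { intros t [Ht [_ [Hcd [_ [Cd _]]]]]. destruct (line_on_of_on_chord u (- t) d0 Hcd Cd) as [al' [be' L']].
    destruct (line_on_unique u al be al' be' c0 d0 (- t) d0 c0 d0) as [-> ->]; auto; lra. }
  assert (BelowL : forall x, - T < x -> exists t, EL t /\ - t < x).
  { intros x Hx. apply NNPP. intro N. assert (T <= - x); [|lra].
    apply LubT. intros t Et. apply Rnot_lt_le. intro. apply N. exists t. split; auto. lra. }
  exists (- T). split; [lra|split].
  - split; [lra|split; [lra|split; [lra|split]]].
    + apply (on_chord_of_line_on u al be). intros x Hx.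
      destruct (Rlt_dec (- T) x).
      * destruct (BelowL x r) as [t [Et Hxt]]. apply (LineL t Et). lra.
      * replace x with (- T) by lra. apply (line_on_left_closed u al be (- T) d0 Cu); try lra.
        intros x' Hx'. destruct (BelowL x' ltac:(lra)) as [t [Et Hxt]]. apply (LineL t Et). lra.
    + intros x Hx. destruct (BelowL x ltac:(lra)) as [t [[_ [_ [_ [_ [_ St]]]]] Hxt]]. apply St. lra.
  - intros e He S. assert (- (- T - e) <= T); [|lra].
    apply UbT. split; [lra|]. replace (- - (- T - e)) with (- T - e) by ring. auto.
Qed.

Lemma strict_segment_max_piece c0 d0 : strict_segment c0 d0 -> exists c d, c <= c0 /\ d0 <= d /\ max_piece c d.
Proof.
  intros S0. destruct (strict_segment_extend_right c0 d0 S0) as [d [Hd [Sd MaxR]]].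
  destruct (strict_segment_extend_left c0 d Sd) as [c [Hc [Sc MaxL]]].
  pose proof Sd as [_ [h2 _]].
  exists c, d. split; [exact Hc|split; [exact Hd|split; [exact Sc|split; [exact MaxL|]]]].
  intros e He S. apply (MaxR e He). apply (strict_segment_sub c (d + e)); auto; lra.
Qed.

Lemma max_piece_unique c d c' d' : max_piece c d -> max_piece c' d' -> Rmax c c' < Rmin d d' -> c = c' /\ d = d'.
Proof.
  intros [S1 [L1 R1]] [S2 [L2 R2]] Ov.
  pose proof S1 as [a1 [a2 [a3 [C1 St1]]]]. pose proof S2 as [b1 [b2 [b3 [C2 St2]]]].
  destruct (line_on_of_on_chord u c d a2 C1) as [al [be P1]]. destruct (line_on_of_on_chord u c' d' b2 C2) as [al' [be' P2]].
  pose proof (Rmax_l c c'). pose proof (Rmax_r c c'). pose proof (Rmin_l d d'). pose proof (Rmin_r d d').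
  destruct (line_on_unique u al be al' be' c d c' d' (Rmax c c') (Rmin d d')) as [-> ->]; auto; try lra.
  assert (U : strict_segment (Rmin c c') (Rmax d d')).
  { pose proof (Rmin_l c c'). pose proof (Rmin_r c c'). pose proof (Rmax_l d d'). pose proof (Rmax_r d d').
    assert (Ma : Rmin c c' = c \/ Rmin c c' = c') by (unfold Rmin; destruct (Rle_dec c c'); auto).
    assert (Mb : Rmax d d' = d \/ Rmax d d' = d') by (unfold Rmax; destruct (Rle_dec d d'); auto).
    split; [lra|split; [lra|split; [lra|split]]].
    - apply (on_chord_of_line_on u al' be'). intros x Hx.
      destruct (Rle_dec x d). { destruct (Rle_dec c x). apply P1; lra. apply P2; lra. }
      apply P2; lra.
    - intros x Hx. destruct (Rlt_dec c x). { destruct (Rlt_dec x d). apply St1; lra. apply St2; lra. }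
      apply St2; lra. }
  assert (Ec : c = c').
  { destruct (Rtotal_order c c') as [H'|[H'|H']]; auto; exfalso.
    - apply (L2 (c' - c) ltac:(lra)). rewrite Rmin_left in U by lra.
      apply (strict_segment_sub c (Rmax d d')); auto; pose proof (Rmax_r d d'); lra.
    - apply (L1 (c - c') ltac:(lra)). rewrite Rmin_right in U by lra.
      apply (strict_segment_sub c' (Rmax d d')); auto; pose proof (Rmax_l d d'); lra. }
  split; [exact Ec|]. subst c'.
  destruct (Rtotal_order d d') as [H'|[H'|H']]; auto; exfalso.
  - apply (R1 (d' - d) ltac:(lra)). rewrite Rmax_right, Rmin_left in U by lra.
    replace (d + (d' - d)) with d' by ring. exact U.
  - apply (R2 (d - d') ltac:(lra)). rewrite Rmax_left, Rmin_left in U by lra.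
    replace (d' + (d - d')) with d by ring. exact U.
Qed.

End StrictPieces.

(** * End conditions of maximal pieces *)

(* Interior chord bounds pass to the endpoints by continuity: shrink [y, x] by [h] on each side. *)
Lemma chord_lower_bound_closure f K y x : cont_on_X f -> 0 <= y -> y < x -> x <= 1 ->
  (forall y' x', 0 < y' -> y' < x' -> x' < 1 -> K * (x' - y') <= f x' - f y') ->
  K * (x - y) <= f x - f y.
Proof.
  intros Cf h1 h2 h3 HK. apply NNPP. intro N. apply Rnot_le_lt in N.
  set (g := K * (x - y) - (f x - f y)). assert (Hg : 0 < g) by (unfold g; lra).
  destruct (Cf y ltac:(unfold inX; lra) (g / 4) ltac:(lra)) as [d1 [Hd1 P1]].
  destruct (Cf x ltac:(unfold inX; lra) (g / 4) ltac:(lra)) as [d2 [Hd2 P2]].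
  set (h := Rmin (Rmin (d1 / 2) (d2 / 2)) (Rmin ((x - y) / 4) (g / (8 * (Rabs K + 1))))).
  pose proof (Rabs_pos K).
  assert (hp : 0 < h).
  { unfold h. apply Rmin_pos; apply Rmin_pos; try lra. apply Rdiv_lt_0_compat; lra. }
  assert (k1 : h <= d1 / 2) by (unfold h; eapply Rle_trans; [apply Rmin_l| apply Rmin_l]).
  assert (k2 : h <= d2 / 2) by (unfold h; eapply Rle_trans; [apply Rmin_l| apply Rmin_r]).
  assert (k3 : h <= (x - y) / 4) by (unfold h; eapply Rle_trans; [apply Rmin_r| apply Rmin_l]).
  assert (k4 : h <= g / (8 * (Rabs K + 1))) by (unfold h; eapply Rle_trans; [apply Rmin_r| apply Rmin_r]).
  specialize (P1 (y + h) ltac:(unfold inX; lra) ltac:(rewrite Rabs_right; lra)).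
  specialize (P2 (x - h) ltac:(unfold inX; lra) ltac:(rewrite Rabs_left; lra)).
  apply Rabs_def2 in P1. apply Rabs_def2 in P2.
  specialize (HK (y + h) (x - h) ltac:(lra) ltac:(lra) ltac:(lra)).
  assert (B : 2 * h * K <= g / 4).
  { assert (2 * h * K <= 2 * h * Rabs K) by (apply Rmult_le_compat_l; [lra| apply Rle_abs]).
    apply (Rmult_le_compat_r (8 * (Rabs K + 1))) in k4; [|lra].
    replace (g / (8 * (Rabs K + 1)) * (8 * (Rabs K + 1))) with g in k4 by (field; lra).
    lra. }
  unfold g in *. lra.
Qed.

Lemma subdiff_chord_bounds_closed sl sh f y x : in_K f -> subdiff_in f sl sh ->
  0 <= y -> y < x -> x <= 1 -> sl * (x - y) <= f x - f y <= sh * (x - y).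
Proof.
  intros Hk Hs h1 h2 h3. pose proof Hk as [Cf _]. split.
  - apply chord_lower_bound_closure; auto. intros y' x' k1 k2 k3.
    apply (subdiff_chord_bounds sl sh f y' x'); auto.
  - enough (- sh * (x - y) <= - f x - - f y) by lra.
    apply (chord_lower_bound_closure (fun z => - f z)); [apply cont_on_X_opp; exact Cf|lra..|].
    intros y' x' k1 k2 k3. pose proof (subdiff_chord_bounds sl sh f y' x' Hk Hs k1 k2 k3). lra.
Qed.

Definition saturated lo hi sl sh u I a b c d : Prop :=
  tangential hi sl sh u c d \/ chordal lo hi sl sh u I a b c d \/
  slope_sat lo hi sl sh u I a b c d \/ boundary_sat lo hi sl sh u I a b c d.

Section EndpointConditions.
Variables (sl sh : R) (lo hi u : R -> R).
Hypothesis Hlo : in_K lo.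
Hypothesis Hhi : in_K hi.
Hypothesis Hlos : subdiff_in lo sl sh.
Hypothesis Hhis : subdiff_in hi sl sh.
Hypothesis Hdiff : forall x, 0 < x < 1 -> exists l, derivable_pt_lim hi x l.
Hypothesis Hu : CFI lo hi sl sh u.

Notation st := (strict_between lo hi u).

Definition left_subgrad_below x p := exists s, s < p /\ forall y, 0 <= y <= x -> u y >= u x + s * (y - x).
Definition right_subgrad_above x p := exists s, p < s /\ forall y, x <= y <= 1 -> u y >= u x + s * (y - x).
Definition hi_supported_at0 p := exists tau, p < tau /\ forall x, inX x -> hi x >= hi 0 + tau * x.
Definition hi_supported_at1 p := exists tau, tau < p /\ forall x, inX x -> hi x >= hi 1 + tau * (x - 1).

(* Conditions at the left end [x0] of a tent under which [tent_not_extreme] applies: either the tent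
   vanishes at [x0], where [u] is below [hi] with slope slack ([x0 > 0]) or has slope strictly inside
   [sl, sh] and, if it touches [hi], lies under a steeper supporting line of [hi] ([x0 = 0]); or
   [x0 = 0] lies strictly between the bounds. *)
Definition left_end_ok x0 p1 e0 e1 := (0 < x0 /\ e0 = 0 /\ left_subgrad_below x0 p1 /\ u x0 < hi x0) \/
  (x0 = 0 /\ e0 = 0 /\ sl < p1 < sh /\ (u 0 < hi 0 \/ hi_supported_at0 p1)) \/ (x0 = 0 /\ e0 = e1 /\ st 0) \/
  (x0 = 0 /\ st 0 /\ sl < p1 < sh).
Definition right_end_ok x2 p2 e1 e2 := (x2 < 1 /\ e2 = 0 /\ right_subgrad_above x2 p2 /\ u x2 < hi x2) \/
  (x2 = 1 /\ e2 = 0 /\ sl < p2 < sh /\ (u 1 < hi 1 \/ hi_supported_at1 p2)) \/ (x2 = 1 /\ e2 = e1 /\ st 1) \/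
  (x2 = 1 /\ st 1 /\ sl < p2 < sh).

Lemma left_end_ok_below_hi x0 x1 p1 e0 e1 : x0 < x1 -> (forall x, x0 < x < x1 -> st x) -> st x1 ->
  left_end_ok x0 p1 e0 e1 ->
  (forall x, x0 <= x <= x1 -> u x < hi x) \/ (x0 = 0 /\ e0 = 0 /\ hi_supported_at0 p1).
Proof.
  intros h01 S01 S1 LE.
  assert (Pin : u x0 < hi x0 -> forall y, x0 <= y <= x1 -> u y < hi y).
  { intros Sy y Hy. destruct (Req_dec y x0) as [->|]; [exact Sy|].
    destruct (Req_dec y x1) as [->|]; [apply S1|]. apply S01; lra. }
  destruct LE as [[_ [_ [_ Hh]]]|[[E0 [E1 [_ [Hh|T]]]]|[[E0 [_ [_ Hh]]]|[E0 [[_ Hh] _]]]]];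
    try (left; apply Pin; subst; auto; fail).
  right. auto.
Qed.

Lemma right_end_ok_below_hi x1 x2 p2 e1 e2 : x1 < x2 -> (forall x, x1 < x < x2 -> st x) -> st x1 ->
  right_end_ok x2 p2 e1 e2 ->
  (forall x, x1 <= x <= x2 -> u x < hi x) \/ (x2 = 1 /\ e2 = 0 /\ hi_supported_at1 p2).
Proof.
  intros h12 S12 S1 RE.
  assert (Pin : u x2 < hi x2 -> forall y, x1 <= y <= x2 -> u y < hi y).
  { intros Sy y Hy. destruct (Req_dec y x2) as [->|]; [exact Sy|].
    destruct (Req_dec y x1) as [->|]; [apply S1|]. apply S12; lra. }
  destruct RE as [[_ [_ [_ Hh]]]|[[E0 [E1 [_ [Hh|T]]]]|[[E0 [_ [_ Hh]]]|[E0 [[_ Hh] _]]]]];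
    try (left; apply Pin; subst; auto; fail).
  right. auto.
Qed.

Lemma kinked_pieces_not_extreme x0 x1 x2 p1 p2 e0 e1 e2 : 0 <= x0 -> x0 < x1 -> x1 < x2 -> x2 <= 1 ->
  (forall x, x0 <= x <= x1 -> u x = u x0 + p1 * (x - x0)) ->
  (forall x, x1 <= x <= x2 -> u x = u x1 + p2 * (x - x1)) ->
  (forall x, x0 < x < x1 -> st x) -> (forall x, x1 < x < x2 -> st x) -> st x1 ->
  left_end_ok x0 p1 e0 e1 -> right_end_ok x2 p2 e1 e2 ->
  (p1 < p2 \/ (e1 - e0) / (x1 - x0) = (e2 - e1) / (x2 - x1)) -> e1 <> 0 ->
  ~ is_extreme (CFI lo hi sl sh) u.
Proof.
  intros h0 h01 h12 h2 A1 A2 S01 S12 S1 LE RE CV1 NZ.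
  assert (F1 : 0 < x0 -> e0 = 0 /\ left_subgrad_below x0 p1).
  { intros H. destruct LE as [[_ [? [? _]]]|[[? _]|[[? _]|[? _]]]]; auto; lra. }
  assert (F3 : e0 <> 0 -> st x0).
  { intros H. destruct LE as [[_ [? _]]|[[_ [? _]]|[[? [_ S]]|[? [S _]]]]]; try contradiction; subst; auto. }
  assert (F5 : x0 = 0 -> e0 = e1 \/ (sl < p1 /\ p1 < sh)).
  { intros H. destruct LE as [[? _]|[[_ [_ [P _]]]|[[_ [E _]]|[_ [_ P]]]]]; [lra|right; auto|left; auto|right; auto]. }
  assert (G1 : x2 < 1 -> e2 = 0 /\ right_subgrad_above x2 p2).
  { intros H. destruct RE as [[_ [? [? _]]]|[[? _]|[[? _]|[? _]]]]; auto; lra. }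
  assert (G3 : e2 <> 0 -> st x2).
  { intros H. destruct RE as [[_ [? _]]|[[_ [? _]]|[[? [_ S]]|[? [S _]]]]]; try contradiction; subst; auto. }
  assert (G5 : x2 = 1 -> e1 = e2 \/ (sl < p2 /\ p2 < sh)).
  { intros H. destruct RE as [[? _]|[[_ [_ [P _]]]|[[_ [E _]]|[_ [_ P]]]]]; [lra|right; auto|left; auto|right; auto]. }
  assert (HI1 := left_end_ok_below_hi x0 x1 p1 e0 e1 h01 S01 S1 LE).
  assert (HI2 := right_end_ok_below_hi x1 x2 p2 e1 e2 h12 S12 S1 RE).
  exact (tent_not_extreme sl sh lo hi u Hlo Hhi Hu x0 x1 x2 p1 p2 e0 e1 e2 h0 h01 h12 h2 A1 A2
    (fun H => proj1 (F1 H)) (fun H => proj1 (G1 H)) (fun H => or_intror (proj2 (F1 H))) CV1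
    (fun H => or_intror (proj2 (G1 H))) F3 (fun _ => S1) G3
    ltac:(destruct HI1 as [H|H]; [left|right; left]; exact H)
    ltac:(destruct HI2 as [H|H]; [left|right; left]; exact H) F5 G5 (or_intror (or_introl NZ))).
Qed.

Lemma left_subgrad_below_of_line c' c p q : c' < c -> 0 <= c' -> c <= 1 ->
  (forall x, c' <= x <= c -> u x = u c' + q * (x - c')) -> q < p -> left_subgrad_below c p.
Proof.
  intros h1 h2 h3 L Hq. exists q. split; auto. intros y Hy.
  pose proof Hu as [[_ Cu] _]. apply convex_X_on01 in Cu.
  pose proof (affine_piece_subgrad 0 1 u c' c q Cu ltac:(lra) h1 h3 L y ltac:(lra)).
  rewrite (L c) in * by lra. lra.
Qed.

Lemma right_subgrad_above_of_line d d' p r : d < d' -> 0 <= d -> d' <= 1 ->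
  (forall x, d <= x <= d' -> u x = u d + r * (x - d)) -> p < r -> right_subgrad_above d p.
Proof.
  intros h1 h2 h3 L Hr. exists r. split; auto. intros y Hy.
  pose proof Hu as [[_ Cu] _]. apply convex_X_on01 in Cu.
  apply (affine_piece_subgrad 0 1 u d d' r Cu); auto; lra.
Qed.

Lemma left_subgrad_below_at_lo c d p : 0 < c -> c < d -> d <= 1 -> u c = lo c ->
  (forall x, c <= x <= d -> u x = u c + p * (x - c)) -> (forall x, c < x < d -> st x) -> left_subgrad_below c p.
Proof.
  intros h1 h2 h3 E L S. apply NNPP. intro N.
  set (x := (c + d) / 2). assert (Sx := S x ltac:(unfold x; lra)). destruct Sx as [Sx _].
  set (s := p - (u x - lo x) / (x - c)).
  assert (Hs : s < p) by (unfold s; assert (0 < (u x - lo x) / (x - c)) by (apply Rdiv_lt_0_compat; unfold x in *; lra); lra).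
  assert (Ex : exists y, 0 <= y <= c /\ u y < u c + s * (y - c)).
  { apply NNPP. intro N2. apply N. exists s. split; auto. intros y Hy. apply Rnot_lt_ge. intro. apply N2. exists y; auto. }
  destruct Ex as [y [Hy Hyu]].
  assert (Hyc : y < c) by (destruct (Req_dec y c); [subst; lra| lra]).
  pose proof Hlo as [_ Cl]. apply convex_X_on01 in Cl.
  pose proof Hu as [_ [Bu _]]. assert (lo y <= u y) by (apply Bu; unfold inX; lra).
  pose proof (convex_slope_adjacent_le 0 1 lo y c x Cl ltac:(lra) Hyc ltac:(unfold x; lra) ltac:(unfold x; lra)).
  rewrite (L x) in Sx by (unfold x; lra).
  assert (A : s * (c - y) < lo c - lo y) by lra.
  assert (B : s * (c - y) * (x - c) < (lo c - lo y) * (x - c)) by (apply Rmult_lt_compat_r; unfold x; lra).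
  assert (C : s * (x - c) < lo x - lo c).
  { apply (Rmult_lt_reg_r (c - y)); [lra|]. nra. }
  unfold s in C.
  replace ((p - (u x - lo x) / (x - c)) * (x - c)) with (p * (x - c) - (u c + p * (x - c) - lo x)) in C.
  2:{ rewrite (L x) by (unfold x; lra). field. unfold x; lra. }
  lra.
Qed.

Lemma right_subgrad_above_at_lo c d p : 0 <= c -> c < d -> d < 1 -> u d = lo d ->
  (forall x, c <= x <= d -> u x = u c + p * (x - c)) -> (forall x, c < x < d -> st x) -> right_subgrad_above d p.
Proof.
  intros h1 h2 h3 E L S. apply NNPP. intro N.
  set (x := (c + d) / 2). assert (Sx := S x ltac:(unfold x; lra)). destruct Sx as [Sx _].
  assert (Ld : forall z, c <= z <= d -> u z = u d + p * (z - d)) by (intros z Hz; rewrite (L z), (L d) by lra; ring).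
  set (s := p + (u x - lo x) / (d - x)).
  assert (Hs : p < s) by (unfold s; assert (0 < (u x - lo x) / (d - x)) by (apply Rdiv_lt_0_compat; unfold x in *; lra); lra).
  assert (Ex : exists y, d <= y <= 1 /\ u y < u d + s * (y - d)).
  { apply NNPP. intro N2. apply N. exists s. split; auto. intros y Hy. apply Rnot_lt_ge. intro. apply N2. exists y; auto. }
  destruct Ex as [y [Hy Hyu]].
  assert (Hyd : d < y) by (destruct (Req_dec y d); [subst; lra| lra]).
  pose proof Hlo as [_ Cl]. apply convex_X_on01 in Cl.
  pose proof Hu as [_ [Bu _]]. assert (lo y <= u y) by (apply Bu; unfold inX; lra).
  pose proof (convex_slope_adjacent_le 0 1 lo x d y Cl ltac:(unfold x; lra) ltac:(unfold x; lra) Hyd ltac:(lra)).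
  rewrite (Ld x) in Sx by (unfold x; lra).
  assert (A : lo y - lo d < s * (y - d)) by lra.
  assert (B : (lo y - lo d) * (d - x) < s * (y - d) * (d - x)) by (apply Rmult_lt_compat_r; unfold x; lra).
  assert (C : lo d - lo x < s * (d - x)).
  { apply (Rmult_lt_reg_r (y - d)); [lra|]. nra. }
  unfold s in C.
  replace ((p + (u x - lo x) / (d - x)) * (d - x)) with (p * (d - x) + (u d + p * (x - d) - lo x)) in C.
  2:{ rewrite (Ld x) by (unfold x; lra). field. unfold x; lra. }
  lra.
Qed.

Lemma sl_lt_of_left_subgrad_below c p : 0 < c -> c <= 1 -> left_subgrad_below c p -> sl < p.
Proof.
  intros h1 h2 [s [Hs H]]. pose proof Hu as [[Ck _] [_ Su]].
  pose proof (H 0 ltac:(lra)).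
  pose proof (subdiff_chord_bounds_closed sl sh u 0 c (conj Ck (proj2 (proj1 Hu))) Su ltac:(lra) h1 h2) as [A _].
  assert (sl * c <= s * c) by lra.
  apply Rmult_le_reg_r in H1; lra.
Qed.

Lemma lt_sh_of_right_subgrad_above d p : 0 <= d -> d < 1 -> right_subgrad_above d p -> p < sh.
Proof.
  intros h1 h2 [s [Hs H]]. pose proof Hu as [[Ck _] [_ Su]].
  pose proof (H 1 ltac:(lra)).
  pose proof (subdiff_chord_bounds_closed sl sh u d 1 (conj Ck (proj2 (proj1 Hu))) Su h1 h2 ltac:(lra)) as [_ A].
  assert (s * (1 - d) <= sh * (1 - d)) by lra.
  apply Rmult_le_reg_r in H1; lra.
Qed.

Lemma tangential_of_hi_left c d p : 0 < c -> c < d -> d <= 1 ->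
  (forall x, c <= x <= d -> u x = u c + p * (x - c)) -> u c = hi c -> tangential hi sl sh u c d.
Proof.
  intros h1 h2 h3 L E. destruct (Hdiff c ltac:(lra)) as [l Hl].
  pose proof Hu as [[_ Cu] [Bu _]]. apply convex_X_on01 in Cu.
  assert (P1 : p <= l).
  { apply (derive_ge_of_right_line hi c l p (d - c) Hl ltac:(lra)). intros h Hh. rewrite <- E.
    replace (u c + p * h) with (u (c + h)) by (rewrite (L (c + h)) by lra; ring). apply Bu. unfold inX; lra. }
  assert (P2 : l <= p).
  { apply (derive_le_of_left_line hi c l p c Hl ltac:(lra)). intros h Hh. rewrite <- E.
    pose proof (affine_piece_subgrad 0 1 u c d p Cu ltac:(lra) h2 h3 L (c - h) ltac:(lra)).
    assert (u (c - h) <= hi (c - h)) by (apply Bu; unfold inX; lra). lra. }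
  exists c, p. split; [left; auto|]. split; [left; split; [lra| replace p with l by lra; auto]|].
  intros x Hx. rewrite (L x), E by auto. ring.
Qed.

Lemma tangential_of_hi_right c d p : 0 <= c -> c < d -> d < 1 ->
  (forall x, c <= x <= d -> u x = u c + p * (x - c)) -> u d = hi d -> tangential hi sl sh u c d.
Proof.
  intros h1 h2 h3 L E. destruct (Hdiff d ltac:(lra)) as [l Hl].
  pose proof Hu as [[_ Cu] [Bu _]]. apply convex_X_on01 in Cu.
  assert (Ld : forall z, c <= z <= d -> u z = u d + p * (z - d)) by (intros z Hz; rewrite (L z), (L d) by lra; ring).
  assert (P1 : p <= l).
  { apply (derive_ge_of_right_line hi d l p (1 - d) Hl ltac:(lra)). intros h Hh. rewrite <- E.
    pose proof (affine_piece_subgrad 0 1 u c d p Cu h1 h2 ltac:(lra) L (d + h) ltac:(lra)).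
    rewrite (L d) in E by lra.
    assert (u (d + h) <= hi (d + h)) by (apply Bu; unfold inX; lra). rewrite (L d) by lra. lra. }
  assert (P2 : l <= p).
  { apply (derive_le_of_left_line hi d l p (d - c) Hl ltac:(lra)). intros h Hh. rewrite <- E.
    rewrite (Ld d) by lra. replace (u d + p * (d - d) - p * h) with (u (d - h)) by (rewrite (Ld (d - h)) by lra; ring).
    apply Bu. unfold inX; lra. }
  exists d, p. split; [right; auto|]. split; [left; split; [lra| replace p with l by lra; auto]|].
  intros x Hx. rewrite (Ld x), E by auto. ring.
Qed.

Lemma hi_supported_at0_of_not_tangential d p : 0 < d -> d <= 1 -> (forall x, 0 <= x <= d -> u x = u 0 + p * (x - 0)) -> u 0 = hi 0 ->
  ~ tangential hi sl sh u 0 d -> hi_supported_at0 p /\ p <> sl.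
Proof.
  intros h1 h2 L E NT. split.
  - apply NNPP. intro N. apply NT. exists 0, p. split; [left; auto|]. split.
    + right; left. split; auto. right. intros eps He.
      assert (Ex : exists x, inX x /\ hi x < hi 0 + (p + eps) * x).
      { apply NNPP. intro N2. apply N. exists (p + eps). split; [lra|]. intros x Hx.
        apply Rnot_lt_ge. intro. apply N2. exists x; auto. }
      destruct Ex as [x [Hx Hhx]].
      assert (x0 : 0 < x) by (unfold inX in Hx; destruct (Req_dec x 0); [subst; lra| lra]).
      exists (Rmin x d). split; [apply Rmin_pos; lra|]. intros h Hh.
      pose proof (Rmin_l x d). pose proof (Rmin_r x d).
      pose proof Hhi as [_ Ch]. apply convex_X_on01 in Ch.
      pose proof Hu as [_ [Bu _]].
      assert (Lb : hi 0 + p * h <= hi h) by (rewrite <- E; replace (u 0 + p * h) with (u h) by (rewrite (L h) by lra; ring); apply Bu; unfold inX; lra).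
      assert (Ub : (hi h - hi 0) * x <= (hi x - hi 0) * h).
      { destruct (Req_dec h x) as [->|]; [lra|]. pose proof (convex_slope_from_le 0 1 hi 0 h x Ch ltac:(lra) ltac:(lra) ltac:(lra) ltac:(unfold inX in Hx; lra)). lra. }
      replace (0 + h) with h by ring.
      assert ((hi h - hi 0) / h - p >= 0).
      { apply Rle_ge. apply (Rmult_le_reg_r h); [lra|]. replace (((hi h - hi 0) / h - p) * h) with (hi h - hi 0 - p * h) by (field; lra). lra. }
      assert ((hi h - hi 0) / h - p < eps).
      { apply (Rmult_lt_reg_r (h * x)); [nra|].
        replace (((hi h - hi 0) / h - p) * (h * x)) with ((hi h - hi 0) * x - p * h * x) by (field; lra).
        assert ((hi x - hi 0) * h < (p + eps) * x * h) by (apply Rmult_lt_compat_r; lra). nra. }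
      rewrite Rabs_right; lra.
    + intros x Hx. rewrite (L x Hx), E. ring.
  - intro Ep. apply NT. exists 0, sl. split; [left; auto|]. split; [right; left; split; auto|].
    intros x Hx. rewrite (L x Hx), E, Ep. ring.
Qed.

Lemma hi_supported_at1_of_not_tangential c p : 0 <= c -> c < 1 -> (forall x, c <= x <= 1 -> u x = u c + p * (x - c)) -> u 1 = hi 1 ->
  ~ tangential hi sl sh u c 1 -> hi_supported_at1 p /\ p <> sh.
Proof.
  intros h1 h2 L0 E NT.
  assert (L : forall x, c <= x <= 1 -> u x = u 1 + p * (x - 1)) by (intros x Hx; rewrite (L0 x), (L0 1) by lra; ring).
  split.
  - apply NNPP. intro N. apply NT. exists 1, p. split; [right; auto|]. split.
    + right; right. split; auto. right. intros eps He.
      assert (Ex : exists x, inX x /\ hi x < hi 1 + (p - eps) * (x - 1)).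
      { apply NNPP. intro N2. apply N. exists (p - eps). split; [lra|]. intros x Hx.
        apply Rnot_lt_ge. intro. apply N2. exists x; auto. }
      destruct Ex as [x [Hx Hhx]].
      assert (x0 : x < 1) by (unfold inX in Hx; destruct (Req_dec x 1); [subst; lra| lra]).
      exists (Rmin (1 - x) (1 - c)). split; [apply Rmin_pos; lra|]. intros h Hh.
      pose proof (Rmin_l (1 - x) (1 - c)). pose proof (Rmin_r (1 - x) (1 - c)).
      pose proof Hhi as [_ Ch]. apply convex_X_on01 in Ch.
      pose proof Hu as [_ [Bu _]].
      assert (Lb : hi 1 - p * h <= hi (1 - h)) by (rewrite <- E; replace (u 1 - p * h) with (u (1 - h)) by (rewrite (L (1 - h)) by lra; ring); apply Bu; unfold inX; lra).
      assert (Ub : (hi 1 - hi x) * h <= (hi 1 - hi (1 - h)) * (1 - x)).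
      { destruct (Req_dec h (1 - x)) as [->|]. { replace (1 - (1 - x)) with x by ring. lra. }
        pose proof (convex_slope_to_le 0 1 hi x (1 - h) 1 Ch ltac:(unfold inX in Hx; lra) ltac:(lra) ltac:(lra) ltac:(lra)).
        replace (1 - (1 - h)) with h in H2 by ring. lra. }
      assert (E1 : (hi (1 - h) - hi 1) / - h = (hi 1 - hi (1 - h)) / h) by (field; lra).
      rewrite E1.
      assert ((hi 1 - hi (1 - h)) / h - p <= 0).
      { apply (Rmult_le_reg_r h); [lra|]. replace (((hi 1 - hi (1 - h)) / h - p) * h) with (hi 1 - hi (1 - h) - p * h) by (field; lra). lra. }
      assert (- eps < (hi 1 - hi (1 - h)) / h - p).
      { apply (Rmult_lt_reg_r (h * (1 - x))); [nra|].
        replace (((hi 1 - hi (1 - h)) / h - p) * (h * (1 - x))) with ((hi 1 - hi (1 - h)) * (1 - x) - p * h * (1 - x)) by (field; lra).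
        assert ((p - eps) * (1 - x) * h < (hi 1 - hi x) * h) by (apply Rmult_lt_compat_r; lra). nra. }
      rewrite Rabs_left1 by lra. lra.
    + intros x Hx. rewrite (L x Hx), E. ring.
  - intro Ep. apply NT. exists 1, sh. split; [right; auto|]. split; [right; right; split; auto|].
    intros x Hx. rewrite (L x Hx), E, Ep. ring.
Qed.

Lemma lo_at0_slope_sl_absurd d : 0 < d -> d <= 1 -> (forall x, 0 <= x <= d -> u x = u 0 + sl * (x - 0)) -> u 0 = lo 0 ->
  (forall x, 0 < x < d -> st x) -> False.
Proof.
  intros h1 h2 L E S. destruct (S (d / 2) ltac:(lra)) as [S1 _].
  pose proof (subdiff_chord_bounds_closed sl sh lo 0 (d / 2) Hlo Hlos ltac:(lra) ltac:(lra) ltac:(lra)) as [A _].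
  rewrite (L (d / 2)) in S1 by lra. lra.
Qed.

Lemma lo_at1_slope_sh_absurd c : 0 <= c -> c < 1 -> (forall x, c <= x <= 1 -> u x = u 1 + sh * (x - 1)) -> u 1 = lo 1 ->
  (forall x, c < x < 1 -> st x) -> False.
Proof.
  intros h1 h2 L E S. destruct (S ((c + 1) / 2) ltac:(lra)) as [S1 _].
  pose proof (subdiff_chord_bounds_closed sl sh lo ((c + 1) / 2) 1 Hlo Hlos ltac:(lra) ltac:(lra) ltac:(lra)) as [_ A].
  rewrite (L ((c + 1) / 2)) in S1 by lra. lra.
Qed.

Lemma hi_at0_slope_sh_absurd d : 0 < d -> d <= 1 -> (forall x, 0 <= x <= d -> u x = u 0 + sh * (x - 0)) -> u 0 = hi 0 ->
  (forall x, 0 < x < d -> st x) -> False.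
Proof.
  intros h1 h2 L E S. destruct (S (d / 2) ltac:(lra)) as [_ S1].
  pose proof (subdiff_chord_bounds_closed sl sh hi 0 (d / 2) Hhi Hhis ltac:(lra) ltac:(lra) ltac:(lra)) as [_ A].
  rewrite (L (d / 2)) in S1 by lra. lra.
Qed.

Lemma hi_at1_slope_sl_absurd c : 0 <= c -> c < 1 -> (forall x, c <= x <= 1 -> u x = u 1 + sl * (x - 1)) -> u 1 = hi 1 ->
  (forall x, c < x < 1 -> st x) -> False.
Proof.
  intros h1 h2 L E S. destruct (S ((c + 1) / 2) ltac:(lra)) as [_ S1].
  pose proof (subdiff_chord_bounds_closed sl sh hi ((c + 1) / 2) 1 Hhi Hhis ltac:(lra) ltac:(lra) ltac:(lra)) as [A _].
  rewrite (L ((c + 1) / 2)) in S1 by lra. lra.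
Qed.

Lemma hi_at_both_ends_absurd p : (forall x, 0 <= x <= 1 -> u x = u 0 + p * (x - 0)) -> u 0 = hi 0 -> u 1 = hi 1 ->
  st (1 / 2) -> False.
Proof.
  intros L E0 E1 [_ S]. pose proof Hhi as [_ Ch]. apply convex_X_on01 in Ch.
  pose proof (convex_on_chord 0 1 hi 0 (1/2) 1 Ch ltac:(lra) ltac:(lra) ltac:(lra) ltac:(lra)).
  rewrite (L (1/2)) in S by lra. rewrite (L 1) in E1 by lra. lra.
Qed.

End EndpointConditions.

Section MaximalPieces.
Variables (sl sh : R) (lo hi u : R -> R).
Hypothesis Hlo : in_K lo.
Hypothesis Hhi : in_K hi.
Hypothesis Hlos : subdiff_in lo sl sh.
Hypothesis Hhis : subdiff_in hi sl sh.
Hypothesis Hdiff : forall x, 0 < x < 1 -> exists l, derivable_pt_lim hi x l.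
Hypothesis Hu : CFI lo hi sl sh u.
Hypothesis Ext : is_extreme (CFI lo hi sl sh) u.

Notation st := (strict_between lo hi u).
Notation Pc := (max_piece lo hi u).

Lemma max_piece_line c d : Pc c d -> forall x, c <= x <= d -> u x = u c + ((u d - u c) / (d - c)) * (x - c).
Proof.
  intros [[h0 [h1 [h2 [C _]]]] _] x Hx. specialize (C x Hx).
  apply (Rmult_eq_reg_l (d - c)); [|lra]. rewrite C. field. lra.
Qed.

Lemma max_piece_strict c d : Pc c d -> forall x, c < x < d -> st x.
Proof. intros [[_ [_ [_ [_ S]]]] _]. auto. Qed.

Lemma max_piece_bounds c d : Pc c d -> 0 <= c /\ c < d /\ d <= 1.
Proof. intros [[h0 [h1 [h2 _]]] _]. auto. Qed.

Lemma max_piece_left_neighbour c d : Pc c d -> 0 < c -> st c ->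
  exists c', Pc c' c /\ (u c - u c') / (c - c') < (u d - u c) / (d - c).
Proof.
  intros PP Hc Sc. pose proof (max_piece_bounds c d PP) as [h0 [h1 h2]].
  destruct (strict_chord_left sl sh lo hi u Hlo Hhi Hu Ext c ltac:(lra) Sc) as [e [He [He2 [C S]]]].
  destruct (strict_segment_max_piece sl sh lo hi u Hu (c - e) c) as [c1 [d1 [Hc1 [Hd1 P1]]]].
  { split; [lra|split; [lra|split; [lra|split; auto]]]. intros x Hx. apply S; lra. }
  pose proof (max_piece_bounds c1 d1 P1) as [k0 [k1 k2]].
  assert (Ed : d1 = c).
  { destruct (Req_dec d1 c); auto. exfalso.
    destruct (max_piece_unique lo hi u c1 d1 c d P1 PP) as [E _].
    - apply Rmax_lub_lt; apply Rmin_glb_lt; lra.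
    - lra. }
  subst d1. exists c1. split; auto.
  pose proof Hu as [[_ Cu] _]. apply convex_X_on01 in Cu.
  pose proof (convex_slope_adjacent_le 0 1 u c1 c d Cu k0 k1 h1 h2).
  assert (Le : (u c - u c1) / (c - c1) <= (u d - u c) / (d - c)).
  { apply (Rmult_le_reg_r ((c - c1) * (d - c))). apply Rmult_lt_0_compat; lra.
    replace ((u c - u c1) / (c - c1) * ((c - c1) * (d - c))) with ((u c - u c1) * (d - c)) by (field; lra).
    replace ((u d - u c) / (d - c) * ((c - c1) * (d - c))) with ((u d - u c) * (c - c1)) by (field; lra). lra. }
  destruct Le as [Lt|Eq]; auto. exfalso.
  assert (Ec : u c = u c1 + ((u d - u c) / (d - c)) * (c - c1)) by (rewrite <- Eq; field; lra).
  pose proof (max_piece_line c d PP) as LP. pose proof (max_piece_line c1 c P1) as LQ. pose proof (max_piece_strict c d PP) as SP0.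
  destruct PP as [_ [ML _]]. apply (ML (c - c1) ltac:(lra)). replace (c - (c - c1)) with c1 by ring.
  rewrite Eq in LQ. set (p := (u d - u c) / (d - c)) in *.
  split; [lra|split; [lra|split; [lra|split]]].
  - apply (on_chord_of_line_on u (u c - p * c) p). intros x Hx.
    destruct (Rle_dec x c).
    + rewrite (LQ x) by lra. lra.
    + rewrite (LP x) by lra. lra.
  - intros x Hx. destruct (Rtotal_order x c) as [H'|[H'|H']].
    + apply (max_piece_strict c1 c P1); lra.
    + subst; auto.
    + apply SP0; lra.
Qed.

Lemma max_piece_right_neighbour c d : Pc c d -> d < 1 -> st d ->
  exists d', Pc d d' /\ (u d - u c) / (d - c) < (u d' - u d) / (d' - d).
Proof.
  intros PP Hd Sd. pose proof (max_piece_bounds c d PP) as [h0 [h1 h2]].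
  destruct (strict_chord_right sl sh lo hi u Hlo Hhi Hu Ext d ltac:(lra) Sd) as [e [He [He2 [C S]]]].
  destruct (strict_segment_max_piece sl sh lo hi u Hu d (d + e)) as [c1 [d1 [Hc1 [Hd1 P1]]]].
  { split; [lra|split; [lra|split; [lra|split; auto]]]. intros x Hx. apply S; lra. }
  pose proof (max_piece_bounds c1 d1 P1) as [k0 [k1 k2]].
  assert (Ec : c1 = d).
  { destruct (Req_dec c1 d); auto. exfalso.
    destruct (max_piece_unique lo hi u c d c1 d1 PP P1) as [_ E].
    - apply Rmax_lub_lt; apply Rmin_glb_lt; lra.
    - lra. }
  subst c1. exists d1. split; auto.
  pose proof Hu as [[_ Cu] _]. apply convex_X_on01 in Cu.
  pose proof (convex_slope_adjacent_le 0 1 u c d d1 Cu h0 h1 k1 k2).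
  assert (Le : (u d - u c) / (d - c) <= (u d1 - u d) / (d1 - d)).
  { apply (Rmult_le_reg_r ((d - c) * (d1 - d))). apply Rmult_lt_0_compat; lra.
    replace ((u d - u c) / (d - c) * ((d - c) * (d1 - d))) with ((u d - u c) * (d1 - d)) by (field; lra).
    replace ((u d1 - u d) / (d1 - d) * ((d - c) * (d1 - d))) with ((u d1 - u d) * (d - c)) by (field; lra). lra. }
  destruct Le as [Lt|Eq]; auto. exfalso.
  pose proof (max_piece_line c d PP) as LP. pose proof (max_piece_line d d1 P1) as LQ. pose proof (max_piece_strict c d PP) as SP0.
  assert (Ed : u d = u c + ((u d - u c) / (d - c)) * (d - c)) by (field; lra).
  destruct PP as [_ [_ MR]]. apply (MR (d1 - d) ltac:(lra)). replace (d + (d1 - d)) with d1 by ring.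
  rewrite <- Eq in LQ. set (p := (u d - u c) / (d - c)) in *.
  split; [lra|split; [lra|split; [lra|split]]].
  - apply (on_chord_of_line_on u (u c - p * c) p). intros x Hx.
    destruct (Rle_dec x d).
    + rewrite (LP x) by lra. lra.
    + rewrite (LQ x) by lra. lra.
  - intros x Hx. destruct (Rtotal_order x d) as [H'|[H'|H']].
    + apply SP0; lra.
    + subst; auto.
    + apply (max_piece_strict d d1 P1); lra.
Qed.

Lemma line_rebase c d p m a' b' : (forall x, c <= x <= d -> u x = u c + p * (x - c)) -> c <= a' -> a' <= m <= b' -> b' <= d ->
  forall x, m <= x <= b' -> u x = u m + p * (x - m).
Proof. intros L h1 h2 h3 x Hx. rewrite (L x), (L m) by lra. ring. Qed.

Lemma max_piece_left_subgrad c d : Pc c d -> 0 < c -> ~ tangential hi sl sh u c d ->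
  left_subgrad_below u c ((u d - u c) / (d - c)) /\ u c < hi c.
Proof.
  intros PP Hc NT. pose proof (max_piece_bounds c d PP) as [h0 [h1 h2]].
  pose proof (max_piece_line c d PP) as L. set (p := (u d - u c) / (d - c)) in *.
  pose proof Hu as [_ [Bu _]]. assert (B := Bu c ltac:(unfold inX; lra)).
  destruct (Req_dec (u c) (hi c)) as [Eh|Nh].
  { exfalso. apply NT. apply (tangential_of_hi_left sl sh lo hi u Hdiff Hu c d p); auto. }
  split; [|lra].
  destruct (Req_dec (u c) (lo c)) as [El|Nl].
  - apply (left_subgrad_below_at_lo sl sh lo hi u Hlo Hu c d p); auto. apply (max_piece_strict c d PP).
  - destruct (max_piece_left_neighbour c d PP Hc ltac:(unfold strict_between; lra)) as [c' [PQ Hq]].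
    pose proof (max_piece_bounds c' c PQ) as [k0 [k1 k2]].
    apply (left_subgrad_below_of_line sl sh lo hi u Hu c' c p ((u c - u c') / (c - c'))); auto; try lra.
    apply (max_piece_line c' c PQ).
Qed.

Lemma max_piece_right_subgrad c d : Pc c d -> d < 1 -> ~ tangential hi sl sh u c d ->
  right_subgrad_above u d ((u d - u c) / (d - c)) /\ u d < hi d.
Proof.
  intros PP Hd NT. pose proof (max_piece_bounds c d PP) as [h0 [h1 h2]].
  pose proof (max_piece_line c d PP) as L. set (p := (u d - u c) / (d - c)) in *.
  pose proof Hu as [_ [Bu _]]. assert (B := Bu d ltac:(unfold inX; lra)).
  destruct (Req_dec (u d) (hi d)) as [Eh|Nh].
  { exfalso. apply NT. apply (tangential_of_hi_right sl sh lo hi u Hdiff Hu c d p); auto. }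
  split; [|lra].
  destruct (Req_dec (u d) (lo d)) as [El|Nl].
  - apply (right_subgrad_above_at_lo sl sh lo hi u Hlo Hu c d p); auto. apply (max_piece_strict c d PP).
  - destruct (max_piece_right_neighbour c d PP Hd ltac:(unfold strict_between; lra)) as [d' [PR Hr]].
    pose proof (max_piece_bounds d d' PR) as [k0 [k1 k2]].
    apply (right_subgrad_above_of_line sl sh lo hi u Hu d d' p ((u d' - u d) / (d' - d))); auto; try lra.
    apply (max_piece_line d d' PR).
Qed.

Lemma max_piece_left_end c d e1 : Pc c d -> ~ tangential hi sl sh u c d ->
  (c = 0 -> ~ st 0 -> (u d - u c) / (d - c) < sh) ->
  left_end_ok sl sh lo hi u c ((u d - u c) / (d - c)) 0 e1 \/ (c = 0 /\ st 0).
Proof.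
  intros PP NT Hsh. pose proof (max_piece_bounds c d PP) as [h0 [h1 h2]].
  pose proof (max_piece_line c d PP) as L. set (p := (u d - u c) / (d - c)) in *.
  assert (SB : sl <= p <= sh) by (apply (CFI_affine_slope_bounds sl sh lo hi u c d); auto).
  destruct (Rlt_dec 0 c) as [Hc|Hc].
  - left. left. destruct (max_piece_left_subgrad c d PP Hc NT) as [F B]. repeat split; auto.
  - assert (E0 : c = 0) by lra. rewrite E0 in *.
    pose proof Hu as [_ [Bu _]]. assert (B := Bu 0 ltac:(unfold inX; lra)).
    destruct (Req_dec (u 0) (lo 0)) as [El|Nl].
    + left. right. left. split; auto. split; auto.
      assert (NS : ~ st 0) by (unfold strict_between; lra).
      assert (Psl : sl < p).
      { destruct (Req_dec p sl) as [Ep|]; [|lra]. exfalso.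
        apply (lo_at0_slope_sl_absurd sl sh lo hi u Hlo Hlos d); auto; try lra.
        - intros x Hx. rewrite <- Ep. apply L; auto.
        - apply (max_piece_strict 0 d PP). }
      split; [split; auto|].
      destruct (Req_dec (u 0) (hi 0)) as [Eh|Nh]; [right|left; lra].
      apply (hi_supported_at0_of_not_tangential sl sh lo hi u Hhi Hu d p); auto; lra.
    + destruct (Req_dec (u 0) (hi 0)) as [Eh|Nh].
      * left. right. left. split; auto. split; auto.
        assert (NS : ~ st 0) by (unfold strict_between; lra).
        destruct (hi_supported_at0_of_not_tangential sl sh lo hi u Hhi Hu d p) as [T Np]; auto; try lra.
        split; [split; [lra| auto]| right; auto].
      * right. split; auto. unfold strict_between; lra.
Qed.

Lemma max_piece_right_end c d e1 : Pc c d -> ~ tangential hi sl sh u c d ->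
  (d = 1 -> ~ st 1 -> sl < (u d - u c) / (d - c)) ->
  right_end_ok sl sh lo hi u d ((u d - u c) / (d - c)) e1 0 \/ (d = 1 /\ st 1).
Proof.
  intros PP NT Hsl. pose proof (max_piece_bounds c d PP) as [h0 [h1 h2]].
  pose proof (max_piece_line c d PP) as L. set (p := (u d - u c) / (d - c)) in *.
  assert (SB : sl <= p <= sh) by (apply (CFI_affine_slope_bounds sl sh lo hi u c d); auto).
  destruct (Rlt_dec d 1) as [Hd|Hd].
  - left. left. destruct (max_piece_right_subgrad c d PP Hd NT) as [F B]. repeat split; auto.
  - assert (E1 : d = 1) by lra. rewrite E1 in *.
    assert (L1 : forall x, c <= x <= 1 -> u x = u 1 + p * (x - 1)) by (intros x Hx; rewrite (L x), (L 1) by lra; ring).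
    pose proof Hu as [_ [Bu _]]. assert (B := Bu 1 ltac:(unfold inX; lra)).
    destruct (Req_dec (u 1) (lo 1)) as [El|Nl].
    + left. right. left. split; auto. split; auto.
      assert (NS : ~ st 1) by (unfold strict_between; lra).
      assert (Psh : p < sh).
      { destruct (Req_dec p sh) as [Ep|]; [|lra]. exfalso.
        apply (lo_at1_slope_sh_absurd sl sh lo hi u Hlo Hlos c); auto; try lra.
        - intros x Hx. rewrite <- Ep. apply L1; auto.
        - apply (max_piece_strict c 1 PP). }
      split; [split; auto|].
      destruct (Req_dec (u 1) (hi 1)) as [Eh|Nh]; [right|left; lra].
      apply (hi_supported_at1_of_not_tangential sl sh lo hi u Hhi Hu c p); auto; lra.
    + destruct (Req_dec (u 1) (hi 1)) as [Eh|Nh].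
      * left. right. left. split; auto. split; auto.
        assert (NS : ~ st 1) by (unfold strict_between; lra).
        destruct (hi_supported_at1_of_not_tangential sl sh lo hi u Hhi Hu c p) as [T Np]; auto; try lra.
        split; [split; [auto| lra]| right; auto].
      * right. split; auto. unfold strict_between; lra.
Qed.

Lemma single_piece_not_extreme c d m e0 e1 e2 : Pc c d -> c < m < d ->
  left_end_ok sl sh lo hi u c ((u d - u c) / (d - c)) e0 e1 -> right_end_ok sl sh lo hi u d ((u d - u c) / (d - c)) e1 e2 ->
  (e1 - e0) / (m - c) = (e2 - e1) / (d - m) -> e1 <> 0 -> False.
Proof.
  intros PP Hm LE RE CV NZ. pose proof (max_piece_bounds c d PP) as [h0 [h1 h2]].
  pose proof (max_piece_line c d PP) as L. pose proof (max_piece_strict c d PP) as S.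
  set (p := (u d - u c) / (d - c)) in *.
  refine (kinked_pieces_not_extreme sl sh lo hi u Hlo Hhi Hu c m d p p e0 e1 e2 _ _ _ _ _ _ _ _ _ LE RE _ NZ Ext).
  all: try lra.
  all: try (right; exact CV).
  all: try (intros x Hx; apply L; lra).
  all: try (apply (line_rebase c d p m m d L); lra).
  all: try (intros x Hx; apply S; lra).
  all: try (apply S; lra).
Qed.

Lemma adjacent_pieces_not_extreme c' c d e0 e2 : Pc c' c -> Pc c d ->
  (u c - u c') / (c - c') < (u d - u c) / (d - c) -> st c ->
  left_end_ok sl sh lo hi u c' ((u c - u c') / (c - c')) e0 1 -> right_end_ok sl sh lo hi u d ((u d - u c) / (d - c)) 1 e2 -> False.
Proof.
  intros PQ PP Hq Sc LE RE. pose proof (max_piece_bounds c d PP) as [h0 [h1 h2]].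
  pose proof (max_piece_bounds c' c PQ) as [k0 [k1 k2]].
  refine (kinked_pieces_not_extreme sl sh lo hi u Hlo Hhi Hu c' c d _ _ e0 1 e2 _ _ _ _ _ _ _ _ _ LE RE _ _ Ext).
  all: try lra.
  all: try (left; exact Hq).
  all: try exact Sc.
  all: try apply (max_piece_line c' c PQ).
  all: try apply (max_piece_line c d PP).
  all: try apply (max_piece_strict c' c PQ).
  all: try apply (max_piece_strict c d PP).
Qed.

Section Collection.
Variables (I : nat -> Prop) (a b : nat -> R).
Hypothesis Honto : forall c d, Pc c d -> exists m, I m /\ a m = c /\ b m = d.

Notation lok := (left_ok lo hi sl sh u I a b).
Notation rok := (right_ok lo hi sl sh u I a b).
Notation sat := (saturated lo hi sl sh u I a b).

Lemma left_ok_of_tangential c' c : Pc c' c -> tangential hi sl sh u c' c -> lok c.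
Proof.
  intros PQ T. destruct (Honto c' c PQ) as [m [Im [Ea Eb]]].
  right. exists m. repeat split; auto. unfold tang_m. rewrite Ea, Eb. exact T.
Qed.

Lemma right_ok_of_tangential d d' : Pc d d' -> tangential hi sl sh u d d' -> rok d.
Proof.
  intros PR T. destruct (Honto d d' PR) as [m [Im [Ea Eb]]].
  right. exists m. repeat split; auto. unfold tang_m. rewrite Ea, Eb. exact T.
Qed.

(* At an interior endpoint strictly between the bounds, a non-tangential piece meets a neighbour
   of smaller slope; unless that neighbour is tangential, the two can be bent at the junction. *)
Lemma max_piece_left_ok c d : Pc c d -> ~ tangential hi sl sh u c d -> 0 < c -> lok c.
Proof.
  intros PP NT Hc. pose proof (max_piece_bounds c d PP) as [h0 [h1 h2]].
  pose proof (max_piece_line c d PP) as L. set (p := (u d - u c) / (d - c)) in *.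
  assert (SB : sl <= p <= sh) by (apply (CFI_affine_slope_bounds sl sh lo hi u c d); auto).
  pose proof (proj1 (proj2 Hu) c ltac:(unfold inX; lra)) as B.
  destruct (Req_dec (u c) (hi c)) as [Eh|Nh].
  { exfalso. apply NT. apply (tangential_of_hi_left sl sh lo hi u Hdiff Hu c d p); auto. }
  destruct (Req_dec (u c) (lo c)) as [El|Nl]; [left; exact El|].
  assert (Sc : st c) by (unfold strict_between; lra).
  destruct (max_piece_left_neighbour c d PP Hc Sc) as [c' [PQ Hq]]. fold p in Hq.
  destruct (classic (tangential hi sl sh u c' c)) as [T|NQ]; [exact (left_ok_of_tangential c' c PQ T)|].
  exfalso. pose proof (max_piece_bounds c' c PQ) as [k0 [k1 k2]].
  assert (SQ : sl <= (u c - u c') / (c - c') <= sh)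
    by (apply (CFI_affine_slope_bounds sl sh lo hi u c' c); auto; apply (max_piece_line c' c PQ)).
  assert (LE : exists e0, left_end_ok sl sh lo hi u c' ((u c - u c') / (c - c')) e0 1).
  { destruct (max_piece_left_end c' c 1 PQ NQ ltac:(intros; lra)) as [H|[H1 H2]]; [exists 0; auto|].
    exists 1. right; right; left. auto. }
  assert (RE : exists e2, right_end_ok sl sh lo hi u d p 1 e2).
  { destruct (max_piece_right_end c d 1 PP NT ltac:(intros; fold p; lra)) as [H|[H1 H2]]; [exists 0; auto|].
    exists 1. right; right; left. auto. }
  destruct LE as [e0 LE]. destruct RE as [e2 RE].
  exact (adjacent_pieces_not_extreme c' c d e0 e2 PQ PP Hq Sc LE RE).
Qed.

Lemma max_piece_right_ok c d : Pc c d -> ~ tangential hi sl sh u c d -> d < 1 -> rok d.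
Proof.
  intros PP NT Hd. pose proof (max_piece_bounds c d PP) as [h0 [h1 h2]].
  pose proof (max_piece_line c d PP) as L. set (p := (u d - u c) / (d - c)) in *.
  assert (SB : sl <= p <= sh) by (apply (CFI_affine_slope_bounds sl sh lo hi u c d); auto).
  pose proof (proj1 (proj2 Hu) d ltac:(unfold inX; lra)) as B.
  destruct (Req_dec (u d) (hi d)) as [Eh|Nh].
  { exfalso. apply NT. apply (tangential_of_hi_right sl sh lo hi u Hdiff Hu c d p); auto. }
  destruct (Req_dec (u d) (lo d)) as [El|Nl]; [left; exact El|].
  assert (Sd : st d) by (unfold strict_between; lra).
  destruct (max_piece_right_neighbour c d PP Hd Sd) as [d' [PR Hr]]. fold p in Hr.
  destruct (classic (tangential hi sl sh u d d')) as [T|NR]; [exact (right_ok_of_tangential d d' PR T)|].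
  exfalso. pose proof (max_piece_bounds d d' PR) as [k0 [k1 k2]].
  assert (SR : sl <= (u d' - u d) / (d' - d) <= sh)
    by (apply (CFI_affine_slope_bounds sl sh lo hi u d d'); auto; apply (max_piece_line d d' PR)).
  assert (LE : exists e0, left_end_ok sl sh lo hi u c p e0 1).
  { destruct (max_piece_left_end c d 1 PP NT ltac:(intros; fold p; lra)) as [H|[H1 H2]]; [exists 0; auto|].
    exists 1. right; right; left. auto. }
  assert (RE : exists e2, right_end_ok sl sh lo hi u d' ((u d' - u d) / (d' - d)) 1 e2).
  { destruct (max_piece_right_end d d' 1 PR NR ltac:(intros; lra)) as [H|[H1 H2]]; [exists 0; auto|].
    exists 1. right; right; left. auto. }
  destruct LE as [e0 LE]. destruct RE as [e2 RE].
  exact (adjacent_pieces_not_extreme c d d' e0 e2 PP PR Hr Sd LE RE).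
Qed.

Lemma max_piece_saturated_at1 c : Pc c 1 -> ~ tangential hi sl sh u c 1 -> 0 < c -> sat c 1.
Proof.
  intros PP NT Hc. pose proof (max_piece_bounds c 1 PP) as [h0 [h1 h2]].
  pose proof (max_piece_line c 1 PP) as L. set (p := (u 1 - u c) / (1 - c)) in *.
  assert (SB : sl <= p <= sh) by (apply (CFI_affine_slope_bounds sl sh lo hi u c 1); auto).
  pose proof (proj1 (proj2 Hu) 1 ltac:(unfold inX; lra)) as B1.
  pose proof (max_piece_left_ok c 1 PP NT Hc) as Lok.
  destruct (Req_dec (u 1) (lo 1)) as [El|Nl]; [right; left; split; [exact Lok|left; exact El]|].
  destruct (Req_dec (u 1) (hi 1)) as [Eh|Nh].
  { right; right; right; right. split; [auto|]. split; [right; exact Eh|exact Lok]. }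
  destruct (Req_dec p sh) as [Ep|Np].
  { right; right; left; right. split; [auto|]. split; [|exact Lok].
    intros x Hx. rewrite <- Ep. apply (affine_derivable_pt_lim u c 1 p); auto. }
  exfalso. destruct (max_piece_left_subgrad c 1 PP Hc NT) as [F Bc]. fold p in F.
  assert (Pl : sl < p) by (apply (sl_lt_of_left_subgrad_below sl sh lo hi u Hu c p); auto; lra).
  apply (single_piece_not_extreme c 1 ((c + 1) / 2) 0 (1 / 2) 1 PP); try lra.
  - left. split; [lra|split; [auto|split; auto]].
  - right; right; right. split; [auto|]. split; [unfold strict_between; lra| fold p; lra].
  - field. lra.
Qed.

Lemma max_piece_saturated_at0 d : Pc 0 d -> ~ tangential hi sl sh u 0 d -> d < 1 -> sat 0 d.
Proof.
  intros PP NT Hd. pose proof (max_piece_bounds 0 d PP) as [h0 [h1 h2]].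
  pose proof (max_piece_line 0 d PP) as L. set (p := (u d - u 0) / (d - 0)) in *.
  assert (SB : sl <= p <= sh) by (apply (CFI_affine_slope_bounds sl sh lo hi u 0 d); auto).
  pose proof (proj1 (proj2 Hu) 0 ltac:(unfold inX; lra)) as B0.
  pose proof (max_piece_right_ok 0 d PP NT Hd) as Rok.
  destruct (Req_dec (u 0) (lo 0)) as [El|Nl]; [right; left; split; [left; exact El|exact Rok]|].
  destruct (Req_dec (u 0) (hi 0)) as [Eh|Nh].
  { right; right; right; left. split; [auto|]. split; [right; exact Eh|exact Rok]. }
  destruct (Req_dec p sl) as [Ep|Np].
  { right; right; left; left. split; [auto|]. split; [|exact Rok].
    intros x Hx. rewrite <- Ep. apply (affine_derivable_pt_lim u 0 d p); auto. }
  exfalso. destruct (max_piece_right_subgrad 0 d PP Hd NT) as [F Bd]. fold p in F.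
  assert (Ph : p < sh) by (apply (lt_sh_of_right_subgrad_above sl sh lo hi u Hu d p); auto; lra).
  apply (single_piece_not_extreme 0 d (d / 2) 1 (1 / 2) 0 PP); try lra.
  - right; right; right. split; [auto|]. split; [unfold strict_between; lra| fold p; lra].
  - left. split; [lra|split; [auto|split; auto]].
  - field. lra.
Qed.

Lemma max_piece_whole_bound_at0 : Pc 0 1 -> ~ tangential hi sl sh u 0 1 ->
  (u 0 = lo 0 \/ u 0 = hi 0) -> sat 0 1.
Proof.
  intros PP NT H0. pose proof (max_piece_line 0 1 PP) as L. set (p := (u 1 - u 0) / (1 - 0)) in *.
  assert (SB : sl <= p <= sh) by (apply (CFI_affine_slope_bounds sl sh lo hi u 0 1); auto; lra).
  assert (L0 : forall x, 0 <= x <= 1 -> u x = u 0 + p * (x - 0)) by (intros x Hx; apply L; auto).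
  pose proof (max_piece_strict 0 1 PP) as S.
  pose proof (proj1 (proj2 Hu) 1 ltac:(unfold inX; lra)) as B1.
  destruct (Req_dec (u 1) (lo 1)) as [El1|Nl1].
  { destruct H0 as [El0|Eh0]; [right; left; split; left; auto|].
    right; right; right; left. split; [auto|]. split; [right; auto|left; auto]. }
  destruct (Req_dec (u 1) (hi 1)) as [Eh1|Nh1].
  { destruct H0 as [El0|Eh0].
    - right; right; right; right. split; [auto|]. split; [right; auto|left; auto].
    - exfalso. exact (hi_at_both_ends_absurd lo hi u Hhi p L0 Eh0 Eh1 (S (1 / 2) ltac:(lra))). }
  destruct (Req_dec p sh) as [Ep|Np].
  { destruct H0 as [El0|Eh0].
    - right; right; left; right. split; [auto|]. split; [|left; auto].
      intros x Hx. rewrite <- Ep. apply (affine_derivable_pt_lim u 0 1 p); auto.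
    - exfalso. rewrite Ep in L0. exact (hi_at0_slope_sh_absurd sl sh lo hi u Hhi Hhis 1
        ltac:(lra) ltac:(lra) L0 Eh0 S). }
  assert (Ph : p < sh) by (destruct SB as [_ [H|H]]; [exact H|contradiction]).
  assert (Pl : sl < p).
  { destruct SB as [[H|H] _]; [exact H|exfalso]. destruct H0 as [El0|Eh0].
    - rewrite <- H in L0. exact (lo_at0_slope_sl_absurd sl sh lo hi u Hlo Hlos 1
        ltac:(lra) ltac:(lra) L0 El0 S).
    - destruct (hi_supported_at0_of_not_tangential sl sh lo hi u Hhi Hu 1 p
        ltac:(lra) ltac:(lra) L0 Eh0 NT) as [_ Nsl].
      exact (Nsl (eq_sym H)). }
  exfalso. destruct (max_piece_left_end 0 1 (1 / 2) PP NT ltac:(intros; fold p; lra)) as [LE|[_ S0]];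
    [|unfold strict_between in S0; lra].
  refine (single_piece_not_extreme 0 1 (1 / 2) 0 (1 / 2) 1 PP _ LE _ _ _); [lra| |field|lra].
  right; right; right. split; [auto|]. split; [unfold strict_between; lra| fold p; lra].
Qed.

Lemma max_piece_whole_strict_at0 : Pc 0 1 -> ~ tangential hi sl sh u 0 1 -> st 0 -> sat 0 1.
Proof.
  intros PP NT S0. pose proof (max_piece_line 0 1 PP) as L. set (p := (u 1 - u 0) / (1 - 0)) in *.
  assert (SB : sl <= p <= sh) by (apply (CFI_affine_slope_bounds sl sh lo hi u 0 1); auto; lra).
  assert (L1 : forall x, 0 <= x <= 1 -> u x = u 1 + p * (x - 1))
    by (intros x Hx; rewrite (L x), (L 1) by lra; ring).
  pose proof (max_piece_strict 0 1 PP) as S.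
  pose proof (proj1 (proj2 Hu) 1 ltac:(unfold inX; lra)) as B1.
  assert (Absurd : sl < p < sh -> ~ st 1 -> False).
  { intros Hp NS1. destruct (max_piece_right_end 0 1 (1 / 2) PP NT ltac:(intros; fold p; lra)) as [RE|[_ S1]];
      [|contradiction].
    refine (single_piece_not_extreme 0 1 (1 / 2) 1 (1 / 2) 0 PP _ _ RE _ _); [lra| |field|lra].
    right; right; right. split; [auto|]. split; [exact S0| fold p; lra]. }
  destruct (Req_dec (u 1) (lo 1)) as [El1|Nl1].
  { destruct (Req_dec p sl) as [Ep|Np].
    - right; right; left; left. split; [auto|]. split; [|left; auto].
      intros x Hx. rewrite <- Ep. apply (affine_derivable_pt_lim u 0 1 p); auto.
    - exfalso. apply Absurd; [|unfold strict_between; lra]. split.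
      + destruct SB as [[H|H] _]; [exact H|contradiction (Np (eq_sym H))].
      + destruct SB as [_ [H|H]]; [exact H|exfalso]. rewrite H in L1.
        exact (lo_at1_slope_sh_absurd sl sh lo hi u Hlo Hlos 0 ltac:(lra) ltac:(lra) L1 El1 S). }
  destruct (Req_dec (u 1) (hi 1)) as [Eh1|Nh1].
  { exfalso. apply Absurd; [|unfold strict_between; lra]. split.
    - destruct SB as [[H|H] _]; [exact H|exfalso]. rewrite <- H in L1.
      exact (hi_at1_slope_sl_absurd sl sh lo hi u Hhi Hhis 0 ltac:(lra) ltac:(lra) L1 Eh1 S).
    - destruct (hi_supported_at1_of_not_tangential sl sh lo hi u Hhi Hu 0 p
        ltac:(lra) ltac:(lra) (fun x Hx => L x Hx) Eh1 NT) as [_ Nsh].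
      destruct SB as [_ [H|H]]; [exact H|contradiction]. }
  exfalso. refine (single_piece_not_extreme 0 1 (1 / 2) 1 1 1 PP _ _ _ _ _); [lra| | |field|lra].
  - right; right; left. split; [auto|]. split; [auto|exact S0].
  - right; right; left. split; [auto|]. split; [auto|unfold strict_between; lra].
Qed.

Lemma max_piece_saturated c d : Pc c d -> sat c d.
Proof.
  intros PP. pose proof (max_piece_bounds c d PP) as [h0 [h1 h2]].
  destruct (classic (tangential hi sl sh u c d)) as [T|NT]; [left; exact T|].
  destruct (Rlt_dec 0 c) as [Hc|Hc]; destruct (Rlt_dec d 1) as [Hd|Hd].
  - right; left. split; [apply (max_piece_left_ok c d)|apply (max_piece_right_ok c d)]; auto.
  - replace d with 1 in * by lra. apply max_piece_saturated_at1; auto.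
  - replace c with 0 in * by lra. apply max_piece_saturated_at0; auto.
  - replace c with 0 in * by lra. replace d with 1 in * by lra.
    pose proof (proj1 (proj2 Hu) 0 ltac:(unfold inX; lra)) as B0.
    destruct (Req_dec (u 0) (lo 0)) as [El|Nl]; [apply max_piece_whole_bound_at0; auto|].
    destruct (Req_dec (u 0) (hi 0)) as [Eh|Nh]; [apply max_piece_whole_bound_at0; auto|].
    apply max_piece_whole_strict_at0; auto. unfold strict_between; lra.
Qed.

Lemma max_piece_item2 c d : Pc c d -> item2 lo hi sl sh u I a b c d.
Proof.
  intros PP. pose proof (max_piece_bounds c d PP) as [h0 [h1 h2]].
  pose proof (max_piece_line c d PP) as L.
  split; [lra|split; [lra|split; [lra|split; [|split]]]].
  - exists (u c - (u d - u c) / (d - c) * c), ((u d - u c) / (d - c)).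
    intros x Hx. rewrite (L x Hx). ring.
  - exact (max_piece_strict c d PP).
  - exact (max_piece_saturated c d PP).
Qed.

End Collection.

End MaximalPieces.

(** * Necessity *)

Definition rat_enum (n : nat) : R := let (i, j) := Cantor.of_nat n in INR i / INR (S j).

Lemma INR_Z_to_nat z : (0 <= z)%Z -> INR (Z.to_nat z) = IZR z.
Proof. intros H. rewrite INR_IZR_INZ. rewrite Z2Nat.id; auto. Qed.

Lemma rat_enum_dense c d : 0 <= c -> c < d -> exists n, c < rat_enum n < d.
Proof.
  intros h0 h1.
  destruct (archimed (2 / (d - c))) as [A1 A2].
  assert (P1 : 0 < 2 / (d - c)) by (apply Rdiv_lt_0_compat; lra).
  set (z := up (2 / (d - c))) in *.
  assert (Zp : (0 <= z)%Z) by (apply le_IZR; lra).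
  set (N := Z.to_nat z).
  assert (HN : INR N = IZR z) by (apply INR_Z_to_nat; auto).
  set (k := INR (S N)).
  assert (Hk : k = INR N + 1) by (unfold k; rewrite S_INR; auto).
  assert (kp : 2 / (d - c) < k) by lra.
  assert (k0 : 0 < k) by lra.
  assert (ik : 1 / k < (d - c) / 2).
  { apply (Rmult_lt_reg_r (k * 2 / (d - c))). apply Rdiv_lt_0_compat; [lra|lra].
    replace (1 / k * (k * 2 / (d - c))) with (2 / (d - c)) by (field; lra).
    replace ((d - c) / 2 * (k * 2 / (d - c))) with k by (field; lra). lra. }
  destruct (archimed (c * k)) as [B1 B2].
  set (w := up (c * k)) in *.
  assert (Wp : (0 <= w)%Z) by (apply le_IZR; assert (0 <= c * k) by (apply Rmult_le_pos; lra); lra).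
  set (i := Z.to_nat w).
  assert (Hi : INR i = IZR w) by (apply INR_Z_to_nat; auto).
  exists (Cantor.to_nat (i, N)). unfold rat_enum. rewrite Cantor.cancel_of_to. fold k.
  rewrite Hi. split.
  - apply (Rmult_lt_reg_r k); auto. replace (IZR w / k * k) with (IZR w) by (field; lra). lra.
  - apply (Rmult_lt_reg_r k); auto. replace (IZR w / k * k) with (IZR w) by (field; lra).
    assert (1 < (d - c) * k).
    { apply (Rmult_lt_reg_r (1 / k)). apply Rdiv_lt_0_compat; lra.
      replace ((d - c) * k * (1 / k)) with (d - c) by (field; lra). lra. }
    lra.
Qed.

Section PieceEnumeration.
Variables (lo hi u : R -> R).

(* Maximal pieces have pairwise disjoint interiors, so indexing each piece by the rationals
   it contains enumerates all of them by [nat]. *)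
Definition piece_index (n : nat) : Prop :=
  exists cd : R * R, max_piece lo hi u (fst cd) (snd cd) /\ fst cd < rat_enum n < snd cd.

Definition piece_at (n : nat) : R * R :=
  match excluded_middle_informative (piece_index n) with
  | left H => proj1_sig (constructive_indefinite_description _ H)
  | right _ => (0, 0)
  end.

Lemma piece_at_spec n : piece_index n ->
  max_piece lo hi u (fst (piece_at n)) (snd (piece_at n)) /\
  fst (piece_at n) < rat_enum n < snd (piece_at n).
Proof.
  intros H. unfold piece_at. destruct (excluded_middle_informative (piece_index n)) as [H'|H'];
    [|contradiction].
  exact (proj2_sig (constructive_indefinite_description _ H')).
Qed.

Lemma piece_at_onto c d : max_piece lo hi u c d ->
  exists m, piece_index m /\ fst (piece_at m) = c /\ snd (piece_at m) = d.
Proof.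
  intros P. pose proof (max_piece_bounds lo hi u c d P) as [h0 [h1 h2]].
  destruct (rat_enum_dense c d h0 h1) as [m Hm].
  assert (Im : piece_index m) by (exists (c, d); simpl; auto).
  exists m. split; [exact Im|].
  destruct (piece_at_spec m Im) as [P' Hm'].
  destruct (max_piece_unique lo hi u c d _ _ P P'); [|auto].
  apply Rmax_lub_lt; apply Rmin_glb_lt; lra.
Qed.

Lemma max_piece_maximal_item2 sl sh I a b c d : max_piece lo hi u c d ->
  maximal_item2 lo hi sl sh u I a b c d.
Proof.
  intros [_ [ML MR]] e He.
  assert (Seg : forall c' d', item2 lo hi sl sh u I a b c' d' -> strict_segment lo hi u c' d').
  { intros c' d' [k0 [k1 [k2 [[p [q Aq]] [St _]]]]].
    split; [lra|split; [lra|split; [lra|split; [|exact St]]]].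
    apply (on_chord_of_line_on u p q). intros x Hx. rewrite (Aq x Hx). ring. }
  split; intros H; [apply (ML e He) | apply (MR e He)]; apply Seg; exact H.
Qed.

End PieceEnumeration.

Lemma strict_between_in_max_piece sl sh lo hi u x : in_K lo -> in_K hi -> CFI lo hi sl sh u ->
  is_extreme (CFI lo hi sl sh) u -> inX x -> strict_between lo hi u x ->
  exists c d, max_piece lo hi u c d /\ c <= x <= d.
Proof.
  intros Hlo Hhi Hu Ext Hx Sx. unfold inX in Hx. destruct (Rlt_dec x 1) as [Hx1|Hx1].
  - destruct (strict_chord_right sl sh lo hi u Hlo Hhi Hu Ext x ltac:(lra) Sx)
      as [e [He [He1 [C S]]]].
    destruct (strict_segment_max_piece sl sh lo hi u Hu x (x + e)) as [c [d [Hc [Hd P]]]].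
    { split; [lra|split; [lra|split; [lra|split; auto]]]. intros y Hy. apply S; lra. }
    exists c, d. split; [exact P|lra].
  - destruct (strict_chord_left sl sh lo hi u Hlo Hhi Hu Ext x ltac:(lra) Sx)
      as [e [He [He1 [C S]]]].
    destruct (strict_segment_max_piece sl sh lo hi u Hu (x - e) x) as [c [d [Hc [Hd P]]]].
    { split; [lra|split; [lra|split; [lra|split; auto]]]. intros y Hy. apply S; lra. }
    pose proof (max_piece_bounds lo hi u c d P). exists c, d. split; [exact P|lra].
Qed.

Lemma extreme_good_collection sl sh lo hi u : in_K lo -> in_K hi ->
  subdiff_in lo sl sh -> subdiff_in hi sl sh ->
  (forall x, 0 < x < 1 -> exists l, derivable_pt_lim hi x l) -> CFI lo hi sl sh u ->
  is_extreme (CFI lo hi sl sh) u ->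
  good_collection lo hi sl sh u (piece_index lo hi u)
    (fun n => fst (piece_at lo hi u n)) (fun n => snd (piece_at lo hi u n)).
Proof.
  intros Hlo Hhi Hlos Hhis Hdiff Hu Ext. split.
  - intros x Hx Out. pose proof (proj1 (proj2 Hu) x Hx) as [B1 B2].
    destruct B1 as [B1|B1]; [|left; auto]. destruct B2 as [B2|B2]; [|right; auto].
    exfalso. destruct (strict_between_in_max_piece sl sh lo hi u x Hlo Hhi Hu Ext Hx (conj B1 B2))
      as [c [d [P Hcd]]].
    destruct (piece_at_onto lo hi u c d P) as [m [Im [Ea Eb]]].
    apply (Out m Im). rewrite Ea, Eb. exact Hcd.
  - intros n Hn. pose proof (proj1 (piece_at_spec lo hi u n Hn)) as P. split.
    + eapply max_piece_item2; eauto using piece_at_onto.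
    + apply max_piece_maximal_item2; exact P.
Qed.

Theorem theorem1 (sl sh : R) (lo hi : R -> R)
  (Hs : sl <= sh)
  (Hlo : in_K lo) (Hhi : in_K hi)
  (Hle : forall x, inX x -> lo x <= hi x)
  (Hlos : subdiff_in lo sl sh) (Hhis : subdiff_in hi sl sh)
  (Hdiff : forall x, 0 < x < 1 -> exists l, derivable_pt_lim hi x l)
  (u : R -> R) (Hu : CFI lo hi sl sh u) :
  is_extreme (CFI lo hi sl sh) u <->
  exists (I : nat -> Prop) (a b : nat -> R),
    good_collection lo hi sl sh u I a b.
Proof.
  split.
  - intros Ext. eexists _, _, _.
    exact (extreme_good_collection sl sh lo hi u Hlo Hhi Hlos Hhis Hdiff Hu Ext).
  - intros [I [a [b G]]]. split; [exact Hu|].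
    exact (good_collection_extreme sl sh lo hi u I a b G).
Qed.
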